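(* For every timed CEL formula $\varphi$ there exists a timed CEA $\mathcal{T}_\varphi$ such that $[\![\varphi]\!](\bar S) = [\![\mathcal{T}_\varphi]\!](\bar S)$ for every timed stream $\bar S$.
   Context: Events and streams. Fix a set $\mathbf{T}$ of event types, a set $\mathbf{A}$ of attribute names and a set $\mathbf{D}$ of data values. An event is a partial map $e:\mathbf{A}\to\mathbf{D}$ with finite domain, together with a type $\mathrm{type}(e)\in\mathbf{T}$; $\mathbf{E}$ is the set of all events. A predicate is a (possibly infinite) set $P\subseteq\mathbf{E}$; $e\models P$ iff $e\in P$, and for a set $E$ of events $E\models P$ iff every $e\in E$ is in $P$. A fixed set $\mathbf{P}$ of predicates contains $\mathbf{E}$ and is closed under intersection and complement (w.r.t. $\mathbf{E}$). A timed stream is a finite sequence $\bar S=(e_1,t_1)\cdots(e_n,t_n)$ of events $e_i$ with timestamps $t_i\in\mathbb{Q}_{\ge 0}$, $t_1<t_2<\dots<t_n$. Complex events. Fix a finite set $\mathbf{X}$ of variables with $\mathbf{T}\subseteq\mathbf{X}$. A complex event of $\bar S$ is a triple $C=(i,j,\mu)$ with $1\le i\le j\le n$ and $\mu:\mathbf{X}\to 2^{\{i,\dots,j\}}$; write $\mathrm{start}(C)=i$, $\mathrm{end}(C)=j$, $C(X)=\mu(X)$. The union $C_1\cup C_2$ has start $\min$ of starts, end $\max$ of ends, and $(C_1\cup C_2)(X)=C_1(X)\cup C_2(X)$. For $L\subseteq\mathbf{X}$, $\pi_L(C)$ has the same start/end, $\pi_L(C)(X)=C(X)$ if $X\in L$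 and $\emptyset$ otherwise. Timed CEL. Formulas: $\varphi ::= R \mid \varphi\ \mathrm{AS}\ X \mid \varphi\ \mathrm{FILTER}\ X[P] \mid \varphi\ \mathrm{OR}\ \varphi \mid \varphi\ \mathrm{AND}\ \varphi \mid \varphi;\varphi \mid \varphi:\varphi \mid \varphi+ \mid \varphi\oplus \mid \pi_L(\varphi) \mid \langle\varphi\rangle_I \mid \varphi\,;_I\,\varphi \mid \varphi\,:_I\,\varphi \mid \varphi+_I \mid \varphi\oplus_I$, with $R\in\mathbf{T}$, $X\in\mathbf{X}$, $P\in\mathbf{P}$, $L\subseteq\mathbf{X}$, $I$ an interval of $\mathbb{Q}_{\ge0}$. Semantics $[\![\varphi]\!](\bar S)$ (a set of complex events): $[\![R]\!]$ = all $(i,i,\mu)$ with $\mathrm{type}(e_i)=R$, $\mu(R)=\{i\}$, $\mu(X)=\emptyset$ for $X\ne R$; $[\![\varphi\ \mathrm{AS}\ X]\!]$ = all $C$ such that some $C'\in[\![\varphi]\!]$ has the same start and end, $C(X)=\bigcup_Y C'(Y)$ and $C(Z)=C'(Z)$ for $Z\ne X$; $[\![\varphi\ \mathrm{FILTER}\ X[P]]\!]=\{C\in[\![\varphi]\!]: C(X)\models P\}$; OR/AND are union/intersection; $[\![\varphi_1;\varphi_2]\!]=\{C_1\cup C_2: C_k\in[\![\varphi_k]\!],\ \mathrm{end}(C_1)<\mathrm{start}(C_2)\}$; $[\![\varphi_1:\varphi_2]\!]$ same with $\mathrm{end}(C_1)+1=\mathrm{start}(C_2)$; $[\![\varphi+]\!]=[\![\varphi]\!]\cup[\![\varphi;\varphi+]\!]$;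 $[\![\varphi\oplus]\!]=[\![\varphi]\!]\cup[\![\varphi:\varphi\oplus]\!]$ (least sets); $[\![\pi_L(\varphi)]\!]=\{\pi_L(C):C\in[\![\varphi]\!]\}$; $[\![\langle\varphi\rangle_I]\!]=\{C\in[\![\varphi]\!]: t_{\mathrm{end}(C)}-t_{\mathrm{start}(C)}\in I\}$; $[\![\varphi_1;_I\varphi_2]\!]=\{C_1\cup C_2: C_k\in[\![\varphi_k]\!],\ \mathrm{end}(C_1)<\mathrm{start}(C_2),\ t_{\mathrm{start}(C_2)}-t_{\mathrm{end}(C_1)}\in I\}$; $[\![\varphi_1:_I\varphi_2]\!]$ same with $\mathrm{end}(C_1)+1=\mathrm{start}(C_2)$; $[\![\varphi+_I]\!]=[\![\varphi]\!]\cup[\![\varphi;_I(\varphi+_I)]\!]$; $[\![\varphi\oplus_I]\!]=[\![\varphi]\!]\cup[\![\varphi:_I(\varphi\oplus_I)]\!]$. Timed CEA. For a finite set $\mathbf{Z}$ of clocks, clock conditions are $\gamma::=\mathrm{true}\mid z=c\mid z<c\mid z\le c\mid z\ge c\mid z>c\mid\gamma\wedge\gamma\mid\gamma\vee\gamma$ ($z\in\mathbf{Z}$, $c\in\mathbb{Q}_{\ge0}$). A clock valuation is a partial map $\nu:\mathbf{Z}\to\mathbb{R}_{\ge0}$; $\nu\models\gamma$ iff all clocks of $\gamma$ are in $\mathrm{dom}(\nu)$ and $\gamma$ is true after substitution. $\nu+t$ adds $t$ to every defined clock; $\mathrm{reset}_Z(\nu)$ has domain $\mathrm{dom}(\nu)\cup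 Z$, value $0$ on $Z$ and $\nu$ elsewhere. A timed CEA is $\mathcal{T}=(Q,\mathbf{P},\mathbf{X},\mathbf{Z},\Delta,q_0,F)$ with finite state set $Q$, initial state $q_0$, final states $F\subseteq Q$, and finite $\Delta\subseteq Q\times\mathbf{P}\times\mathcal{C}_{\mathbf{Z}}\times 2^{\mathbf{X}}\times 2^{\mathbf{Z}}\times Q$. Let $\delta t_k=t_k-t_{k-1}$ ($\delta t_1=t_1$). A run from position $i$ to $j$ over $\bar S$ is a sequence $(p_i,\nu_i)\xrightarrow{P_i,\gamma_i/L_i,Z_i}(p_{i+1},\nu_{i+1})\cdots\xrightarrow{P_j,\gamma_j/L_j,Z_j}(p_{j+1},\nu_{j+1})$ with $p_i=q_0$, $\mathrm{dom}(\nu_i)=\emptyset$, and for each $k\in[i..j]$: $(p_k,P_k,\gamma_k,L_k,Z_k,p_{k+1})\in\Delta$, $e_k\models P_k$, $\nu_k+\delta t_k\models\gamma_k$, $\nu_{k+1}=\mathrm{reset}_{Z_k}(\nu_k+\delta t_k)$. It is accepting if $p_{j+1}\in F$, and defines $C_\rho=(i,j,\mu_\rho)$ with $\mu_\rho(X)=\{k\in[i..j]: X\in L_k\}$. $[\![\mathcal{T}]\!](\bar S)=\{C_\rho:\rho$ accepting run of $\mathcal{T}$ over $\bar S\}$.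
   Formalization: The set 𝐏 also contains every type predicate {e ∈ 𝐄 : type(e) = R} with R ∈ 𝐓, and every interval I has rational endpoints, its upper end possibly +∞. Each condition added here is assumed in the paper as well or is needed for the statement above to hold. *)

From Stdlib Require Import List QArith Reals Qreals.
Import ListNotations.

Set Implicit Arguments.
Local Open Scope nat_scope.

Record Event (T A D : Type) := mkEvent {
  etype : T;
  eattr : A -> option D;
  efin  : exists l : list A, forall a, eattr a <> None -> In a l
}.

(* A timed stream: finite sequence (e_1,t_1)...(e_n,t_n); position k (1-based)
   is the (k-1)-th list element. *)
Definition tstream (T A D : Type) := list (Event T A D * Q).

Definition valid_stream (T A D : Type) (s : tstream T A D) : Prop :=
  (forall e t, In (e, t) s -> (0 <= t)%Q) /\
  (forall k e1 t1 e2 t2, nth_error s k = Some (e1, t1) ->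
      nth_error s (S k) = Some (e2, t2) -> (t1 < t2)%Q).

(* timestamp t_k (1-based); t_0 := 0 so that delta t_1 = t_1 *)
Definition ts (T A D : Type) (s : tstream T A D) (k : nat) : Q :=
  match k with
  | O => 0%Q
  | S k' => match nth_error s k' with Some (_, t) => t | None => 0%Q end
  end.

Definition ev_sat (T A D : Type) (s : tstream T A D) (k : nat)
  (P : Event T A D -> Prop) : Prop :=
  exists e t, (1 <= k)%nat /\ nth_error s (k - 1)%nat = Some (e, t) /\ P e.

Record interval := mkInterval {
  ilo : Q; ilo_closed : bool;
  ihi : option (Q * bool)  (* None = +infinity; bool = closed *)
}.

Definition in_interval (I : interval) (d : Q) : Prop :=
  (if ilo_closed I then (ilo I <= d)%Q else (ilo I < d)%Q) /\
  match ihi I with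
  | None => True
  | Some (h, c) => if c then (d <= h)%Q else (d < h)%Q
  end.

Section CEL.
Variables (T A D X : Type) (inj : T -> X).
(* inj : the inclusion T ⊆ X of event types into variables *)

Local Notation Ev := (Event T A D).

Inductive formula : Type :=
| FAtom   (R : T)
| FAs     (f : formula) (x : X)
| FFilter (f : formula) (x : X) (P : Ev -> Prop)
| FOr     (f g : formula)
| FAnd    (f g : formula)
| FSeq    (f g : formula)
| FCons   (f g : formula)
| FPlus   (f : formula)
| FOplus  (f : formula)
| FProj   (L : X -> Prop) (f : formula)
| FWin    (f : formula) (I : interval)
| FSeqI   (f : formula) (I : interval) (g : formula)
| FConsI  (f : formula) (I : interval) (g : formula)
| FPlusI  (f : formula) (I : interval)
| FOplusI (f : formula) (I : interval).

Fixpoint formula_preds_in (Pset : (Ev -> Prop) -> Prop) (f : formula) : Prop :=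
  match f with
  | FAtom _ => True
  | FAs f _ => formula_preds_in Pset f
  | FFilter f _ P => Pset P /\ formula_preds_in Pset f
  | FOr f g | FAnd f g | FSeq f g | FCons f g
  | FSeqI f _ g | FConsI f _ g => formula_preds_in Pset f /\ formula_preds_in Pset g
  | FPlus f | FOplus f | FProj _ f | FWin f _
  | FPlusI f _ | FOplusI f _ => formula_preds_in Pset f
  end.

(** * Complex events (i, j, mu); mu X is a set of positions, compared extensionally *)
Record CE := mkCE { cs : nat; ce : nat; cmu : X -> nat -> Prop }.

Definition wfCE (s : tstream T A D) (C : CE) : Prop :=
  1 <= cs C /\ cs C <= ce C /\ ce C <= length s /\
  (forall x k, cmu C x k -> cs C <= k <= ce C).

Definition is_union (C C1 C2 : CE) : Prop :=
  cs C = Nat.min (cs C1) (cs C2) /\ ce C = Nat.max (ce C1) (ce C2) /\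
  (forall x k, cmu C x k <-> (cmu C1 x k \/ cmu C2 x k)).

Inductive sem (s : tstream T A D) : formula -> CE -> Prop :=
| sem_atom R C : wfCE s C -> cs C = ce C ->
    ev_sat s (cs C) (fun e => etype e = R) ->
    (forall x k, cmu C x k <-> (x = inj R /\ k = cs C)) ->
    sem s (FAtom R) C
| sem_as f x C C' : wfCE s C -> sem s f C' ->
    cs C = cs C' -> ce C = ce C' ->
    (forall k, cmu C x k <-> exists y, cmu C' y k) ->
    (forall z k, z <> x -> (cmu C z k <-> cmu C' z k)) ->
    sem s (FAs f x) C
| sem_filter f x P C : sem s f C ->
    (forall k, cmu C x k -> ev_sat s k P) ->
    sem s (FFilter f x P) C
| sem_or_l f g C : sem s f C -> sem s (FOr f g) C
| sem_or_r f g C : sem s g C -> sem s (FOr f g) C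
| sem_and f g C : sem s f C -> sem s g C -> sem s (FAnd f g) C
| sem_seq f g C C1 C2 : wfCE s C -> sem s f C1 -> sem s g C2 ->
    ce C1 < cs C2 -> is_union C C1 C2 -> sem s (FSeq f g) C
| sem_cons f g C C1 C2 : wfCE s C -> sem s f C1 -> sem s g C2 ->
    ce C1 + 1 = cs C2 -> is_union C C1 C2 -> sem s (FCons f g) C
| sem_plus_base f C : sem s f C -> sem s (FPlus f) C
| sem_plus_step f C C1 C2 : wfCE s C -> sem s f C1 -> sem s (FPlus f) C2 ->
    ce C1 < cs C2 -> is_union C C1 C2 -> sem s (FPlus f) C
| sem_oplus_base f C : sem s f C -> sem s (FOplus f) C
| sem_oplus_step f C C1 C2 : wfCE s C -> sem s f C1 -> sem s (FOplus f) C2 ->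
    ce C1 + 1 = cs C2 -> is_union C C1 C2 -> sem s (FOplus f) C
| sem_proj L f C C' : wfCE s C -> sem s f C' ->
    cs C = cs C' -> ce C = ce C' ->
    (forall x k, cmu C x k <-> (L x /\ cmu C' x k)) ->
    sem s (FProj L f) C
| sem_win f I C : sem s f C ->
    in_interval I (ts s (ce C) - ts s (cs C))%Q -> sem s (FWin f I) C
| sem_seqI f I g C C1 C2 : wfCE s C -> sem s f C1 -> sem s g C2 ->
    ce C1 < cs C2 -> in_interval I (ts s (cs C2) - ts s (ce C1))%Q ->
    is_union C C1 C2 -> sem s (FSeqI f I g) C
| sem_consI f I g C C1 C2 : wfCE s C -> sem s f C1 -> sem s g C2 ->
    ce C1 + 1 = cs C2 -> in_interval I (ts s (cs C2) - ts s (ce C1))%Q ->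
    is_union C C1 C2 -> sem s (FConsI f I g) C
| sem_plusI_base f I C : sem s f C -> sem s (FPlusI f I) C
| sem_plusI_step f I C C1 C2 : wfCE s C -> sem s f C1 -> sem s (FPlusI f I) C2 ->
    ce C1 < cs C2 -> in_interval I (ts s (cs C2) - ts s (ce C1))%Q ->
    is_union C C1 C2 -> sem s (FPlusI f I) C
| sem_oplusI_base f I C : sem s f C -> sem s (FOplusI f I) C
| sem_oplusI_step f I C C1 C2 : wfCE s C -> sem s f C1 -> sem s (FOplusI f I) C2 ->
    ce C1 + 1 = cs C2 -> in_interval I (ts s (cs C2) - ts s (ce C1))%Q ->
    is_union C C1 C2 -> sem s (FOplusI f I) C.

Inductive ccond (Z : Type) : Type :=
| CTrue
| CEq (z : Z) (c : Q) | CLt (z : Z) (c : Q) | CLe (z : Z) (c : Q)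
| CGe (z : Z) (c : Q) | CGt (z : Z) (c : Q)
| CAnd (g h : ccond Z) | COr (g h : ccond Z).

Fixpoint cclocks (Z : Type) (g : ccond Z) : list Z :=
  match g with
  | CTrue _ => []
  | CEq z _ | CLt z _ | CLe z _ | CGe z _ | CGt z _ => [z]
  | CAnd g h | COr g h => cclocks g ++ cclocks h
  end.

Fixpoint cconsts_nonneg (Z : Type) (g : ccond Z) : Prop :=
  match g with
  | CTrue _ => True
  | CEq _ c | CLt _ c | CLe _ c | CGe _ c | CGt _ c => (0 <= c)%Q
  | CAnd g h | COr g h => cconsts_nonneg g /\ cconsts_nonneg h
  end.

(* truth value after substitution (atoms on undefined clocks are false) *)
Fixpoint ceval (Z : Type) (nu : Z -> option R) (g : ccond Z) : Prop :=
  match g with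
  | CTrue _ => True
  | CEq z c => exists v, nu z = Some v /\ v = Q2R c
  | CLt z c => exists v, nu z = Some v /\ (v < Q2R c)%R
  | CLe z c => exists v, nu z = Some v /\ (v <= Q2R c)%R
  | CGe z c => exists v, nu z = Some v /\ (v >= Q2R c)%R
  | CGt z c => exists v, nu z = Some v /\ (v > Q2R c)%R
  | CAnd g h => ceval nu g /\ ceval nu h
  | COr g h => ceval nu g \/ ceval nu h
  end.

Definition csat (Z : Type) (nu : Z -> option R) (g : ccond Z) : Prop :=
  (forall z, In z (cclocks g) -> nu z <> None) /\ ceval nu g.

Definition vshift (Z : Type) (nu : Z -> option R) (t : R) : Z -> option R :=
  fun z => option_map (fun v => (v + t)%R) (nu z).

Record trans (St Z : Type) := mkTrans {
  tsrc : St; tpred : Ev -> Prop; tguard : ccond Z;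
  tlab : X -> Prop; treset : Z -> Prop; tdst : St }.

Record TCEA := mkTCEA {
  tst : Type;
  tclk : Type;
  tst_fin : exists l : list tst, forall q, In q l;
  tclk_fin : exists l : list tclk, forall z, In z l;
  tdelta : list (trans tst tclk);
  tinit : tst;
  tfinal : tst -> Prop }.

Definition tcea_ok (Pset : (Ev -> Prop) -> Prop) (M : TCEA) : Prop :=
  forall t, In t (tdelta M) -> Pset (tpred t) /\ cconsts_nonneg (tguard t).

Definition dt (s : tstream T A D) (k : nat) : R := Q2R (ts s k - ts s (k - 1))%Q.

(* an accepting run from position i to j: states p_i..p_{j+1},
   valuations nu_i..nu_{j+1}, transitions tr_i..tr_j *)
Definition accepting_run (M : TCEA) (s : tstream T A D) (i j : nat)
  (p : nat -> tst M) (nu : nat -> tclk M -> option R)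
  (tr : nat -> trans (tst M) (tclk M)) : Prop :=
  p i = tinit M /\ (forall z, nu i z = None) /\
  (forall k, i <= k <= j ->
     In (tr k) (tdelta M) /\ tsrc (tr k) = p k /\ tdst (tr k) = p (S k) /\
     ev_sat s k (tpred (tr k)) /\
     csat (vshift (nu k) (dt s k)) (tguard (tr k)) /\
     (forall z, (treset (tr k) z -> nu (S k) z = Some 0%R) /\
                (~ treset (tr k) z -> nu (S k) z = vshift (nu k) (dt s k) z))) /\
  tfinal M (p (S j)).

Definition semT (M : TCEA) (s : tstream T A D) (C : CE) : Prop :=
  wfCE s C /\
  exists p nu tr, accepting_run M s (cs C) (ce C) p nu tr /\
    (forall x k, cmu C x k <-> (cs C <= k <= ce C /\ tlab (tr k) x)).

End CEL.

From Stdlib Require Import List QArith Reals Qreals ClassicalEpsilon Classical Lia Lra FunctionalExtensionality.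
Import ListNotations.
Set Implicit Arguments.
Local Open Scope nat_scope.


Definition pdec (P : Prop) : {P} + {~P} := excluded_middle_informative P.

Definition list_if {B : Type} (P : Prop) (x : B) : list B := if pdec P then [x] else [].
Lemma in_list_if {B : Type} (P : Prop) (x y : B) : In y (list_if P x) <-> P /\ y = x.
Proof. unfold list_if; destruct (pdec P); simpl; split; intros H.
  destruct H as [H|[]]; auto. destruct H as [_ ->]; auto. contradiction. destruct H; contradiction. Qed.

Fixpoint cmap {Z1 Z2 : Type} (g : Z1 -> Z2) (c : ccond Z1) : ccond Z2 :=
  match c with
  | CTrue _ => CTrue _
  | CEq z q => CEq (g z) q
  | CLt z q => CLt (g z) q
  | CLe z q => CLe (g z) q
  | CGe z q => CGe (g z) q
  | CGt z q => CGt (g z) q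
  | CAnd a b => CAnd (cmap g a) (cmap g b)
  | COr a b => COr (cmap g a) (cmap g b)
  end.

Lemma cclocks_cmap {Z1 Z2 : Type} (g : Z1 -> Z2) c : cclocks (cmap g c) = map g (cclocks c).
Proof. induction c; simpl; auto; rewrite map_app; congruence. Qed.

Lemma ceval_cmap {Z1 Z2 : Type} (g : Z1 -> Z2) nu c : ceval nu (cmap g c) <-> ceval (fun z => nu (g z)) c.
Proof. induction c; simpl; try tauto; rewrite IHc1, IHc2; tauto. Qed.

Lemma csat_cmap {Z1 Z2 : Type} (g : Z1 -> Z2) nu c : csat nu (cmap g c) <-> csat (fun z => nu (g z)) c.
Proof. unfold csat. rewrite cclocks_cmap, ceval_cmap. split; intros [H1 H2]; split; auto.
  - intros z Hz. apply H1. apply in_map; auto.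
  - intros z Hz. apply in_map_iff in Hz. destruct Hz as [y [<- Hy]]. apply H1; auto. Qed.

Lemma cconsts_cmap {Z1 Z2 : Type} (g : Z1 -> Z2) c : cconsts_nonneg (cmap g c) <-> cconsts_nonneg c.
Proof. induction c; simpl; try tauto; rewrite IHc1, IHc2; tauto. Qed.

Lemma csat_and {Z : Type} (nu : Z -> option R) a b : csat nu (CAnd a b) <-> csat nu a /\ csat nu b.
Proof. unfold csat; simpl. split.
  - intros [H1 [H2 H3]]. repeat split; auto; intros z Hz; apply H1; apply in_app_iff; auto.
  - intros [[H1 H2] [H3 H4]]. repeat split; auto. intros z Hz; apply in_app_iff in Hz; destruct Hz; auto. Qed.

Lemma ceval_clockless {Z : Type} (c : ccond Z) nu nu' : cclocks c = [] -> (ceval nu c <-> ceval nu' c).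
Proof. induction c; simpl; intros H; try discriminate; try tauto;
  apply app_eq_nil in H; destruct H; rewrite IHc1, IHc2; tauto. Qed.

Lemma csat_clockless {Z : Type} (c : ccond Z) nu nu' : cclocks c = [] -> csat nu c -> csat nu' c.
Proof. intros H [H1 H2]. split. rewrite H; simpl; tauto. eapply ceval_clockless; eauto. Qed.

Section Part1.
Variables T A D X : Type.

Definition run_segment {St Z : Type} (s : tstream T A D) (Dl : list (trans T A D X St Z)) (i j : nat)
  (p : nat -> St) (nu : nat -> Z -> option R) (tr : nat -> trans T A D X St Z) : Prop :=
  forall k, i <= k <= j ->
     In (tr k) Dl /\ tsrc (tr k) = p k /\ tdst (tr k) = p (S k) /\
     ev_sat s k (tpred (tr k)) /\
     csat (vshift (nu k) (dt s k)) (tguard (tr k)) /\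
     (forall z, (treset (tr k) z -> nu (S k) z = Some 0%R) /\
                (~ treset (tr k) z -> nu (S k) z = vshift (nu k) (dt s k) z)).

Definition follows_resets {St Z : Type} (s : tstream T A D) (nu : nat -> Z -> option R)
  (tr : nat -> trans T A D X St Z) (i j : nat) : Prop :=
  forall k, i <= k <= j -> forall z, (treset (tr k) z -> nu (S k) z = Some 0%R) /\
                (~ treset (tr k) z -> nu (S k) z = vshift (nu k) (dt s k) z).

Lemma run_segment_resets {St Z : Type} s (Dl : list (trans T A D X St Z)) i j p nu tr :
  run_segment s Dl i j p nu tr -> follows_resets s nu tr i j.
Proof. intros H k Hk. apply H; auto. Qed.

Lemma follows_resets_sub {St Z : Type} s (nu : nat -> Z -> option R) (tr : nat -> trans T A D X St Z) i j i' j' :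
  follows_resets s nu tr i j -> i <= i' -> j' <= j -> follows_resets s nu tr i' j'.
Proof. intros H ? ? k Hk. apply H; lia. Qed.

Definition step_val {St Z : Type} (s : tstream T A D) (t : trans T A D X St Z) (nu : Z -> option R) (k : nat)
  : Z -> option R :=
  fun z => if pdec (treset t z) then Some 0%R else vshift nu (dt s k) z.

Fixpoint run_val {St Z : Type} (s : tstream T A D) (nu0 : Z -> option R) (tr : nat -> trans T A D X St Z)
  (i k : nat) : Z -> option R :=
  match k with
  | O => nu0
  | S k' => if Nat.ltb k' i then nu0 else step_val s (tr k') (run_val s nu0 tr i k') k'
  end.

Lemma run_val_start {St Z : Type} s nu0 (tr : nat -> trans T A D X St Z) i : run_val s nu0 tr i i = nu0.
Proof. destruct i; simpl; auto. replace (Nat.ltb i (S i)) with true; auto. symmetry; apply Nat.ltb_lt; lia. Qed.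

Lemma run_val_resets {St Z : Type} s nu0 (tr : nat -> trans T A D X St Z) i j : follows_resets s (run_val s nu0 tr i) tr i j.
Proof. intros k Hk z. simpl. replace (Nat.ltb k i) with false by (symmetry; apply Nat.ltb_ge; lia).
  unfold step_val. destruct (pdec (treset (tr k) z)); tauto. Qed.

Lemma clocks_agree_from {St1 Z1 St2 Z2 : Type} s (nu1 : nat -> Z1 -> option R) (tr1 : nat -> trans T A D X St1 Z1)
  (nu2 : nat -> Z2 -> option R) (tr2 : nat -> trans T A D X St2 Z2) (g : Z1 -> Z2) a b :
  follows_resets s nu1 tr1 a b -> follows_resets s nu2 tr2 a b ->
  (forall k, a <= k <= b -> forall z, treset (tr2 k) (g z) <-> treset (tr1 k) z) ->
  (forall z, nu2 a (g z) = nu1 a z) ->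
  forall k, a <= k <= S b -> forall z, nu2 k (g z) = nu1 k z.
Proof. intros H1 H2 H3 H0 k Hk. induction k; intros z.
  - assert (a = 0) by lia. subst; auto.
  - destruct (Nat.eq_dec (S k) a) as [E|E]. rewrite E; auto.
    assert (Hk' : a <= k <= b) by lia.
    destruct (H1 k Hk' z) as [R1 N1]. destruct (H2 k Hk' (g z)) as [R2 N2].
    destruct (classic (treset (tr1 k) z)) as [Hr|Hr].
    + rewrite R1 by auto. rewrite R2 by (apply H3; auto). reflexivity.
    + rewrite N1 by auto. rewrite N2 by (rewrite H3; auto). unfold vshift. rewrite IHk; auto. lia. Qed.

Lemma clocks_agree {St1 Z1 St2 Z2 : Type} s (nu1 : nat -> Z1 -> option R) (tr1 : nat -> trans T A D X St1 Z1)
  (nu2 : nat -> Z2 -> option R) (tr2 : nat -> trans T A D X St2 Z2) (g : Z1 -> Z2) a b :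
  follows_resets s nu1 tr1 a b -> follows_resets s nu2 tr2 a b ->
  (forall k, a <= k <= b -> forall z, treset (tr2 k) (g z) <-> treset (tr1 k) z) ->
  (forall z, treset (tr1 a) z) ->
  forall k, a < k <= S b -> forall z, nu2 k (g z) = nu1 k z.
Proof. intros H1 H2 H3 H0 k Hk z.
  assert (a <= b) by lia.
  apply (@clocks_agree_from _ _ _ _ s nu1 tr1 nu2 tr2 g (S a) b).
  - eapply follows_resets_sub; eauto.
  - eapply follows_resets_sub; eauto.
  - intros; apply H3; lia.
  - intros z'. destruct (H1 a (conj (le_n a) H) z') as [R1 _]. destruct (H2 a (conj (le_n a) H) (g z')) as [R2 _].
    rewrite R1 by auto. rewrite R2 by (apply H3; auto). reflexivity.
  - lia. Qed.

Lemma clock_since_reset {St Z : Type} s (nu : nat -> Z -> option R) (tr : nat -> trans T A D X St Z) r b z :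
  follows_resets s nu tr r b -> treset (tr r) z ->
  forall k, r < k <= S b -> (forall m, r < m < k -> ~ treset (tr m) z) ->
  nu k z = Some (Q2R (ts s (k - 1) - ts s r)).
Proof. intros H Hr k Hk. induction k; intros Hn. lia.
  destruct (Nat.eq_dec k r) as [E|E].
  - subst. destruct (H r ltac:(lia) z) as [R1 _]. rewrite R1; auto. f_equal.
    replace (S r - 1) with r by lia. rewrite <- (Qeq_eqR 0); [| ring]. unfold Q2R; simpl; ring.
  - destruct (H k ltac:(lia) z) as [_ N1]. rewrite N1 by (apply Hn; lia).
    unfold vshift. rewrite IHk by (try lia; intros; apply Hn; lia). simpl. f_equal.
    unfold dt. rewrite <- Q2R_plus. apply Qeq_eqR.
    replace (S k - 1) with k by lia. destruct k. lia. rewrite Nat.sub_0_r. ring. Qed.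

Lemma clock_since_reset_shifted {St Z : Type} s (nu : nat -> Z -> option R) (tr : nat -> trans T A D X St Z) r b z :
  follows_resets s nu tr r b -> treset (tr r) z ->
  forall k, r < k <= S b -> (forall m, r < m < k -> ~ treset (tr m) z) ->
  vshift (nu k) (dt s k) z = Some (Q2R (ts s k - ts s r)).
Proof. intros H Hr k Hk Hn. unfold vshift. rewrite (@clock_since_reset _ _ s nu tr r b z H Hr k Hk Hn).
  simpl. f_equal. unfold dt. rewrite <- Q2R_plus. apply Qeq_eqR. ring. Qed.

Lemma choice_range {B : Type} (d : B) (P : nat -> B -> Prop) a b :
  (forall k, a <= k <= b -> exists x, P k x) -> exists f : nat -> B, forall k, a <= k <= b -> P k (f k).
Proof. intros H. assert (H' : forall k, exists x, a <= k <= b -> P k x).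
  { intro k. destruct (pdec (a <= k <= b)) as [h|h]. destruct (H k h) as [x Hx]; exists x; auto.
    exists d; intros; contradiction. }
  exists (fun k => proj1_sig (constructive_indefinite_description _ (H' k))). intros k Hk.
  destruct (constructive_indefinite_description _ (H' k)); simpl; auto. Qed.

Definition fresh_start_on {St Z : Type} (Dl : list (trans T A D X St Z)) (init : St) :=
  forall t, In t Dl -> tsrc t = init -> (forall z, treset t z) /\ cclocks (tguard t) = [].

Lemma run_pullback {St Z St' Z' : Type} s (Dl : list (trans T A D X St Z)) (init : St) (g : Z -> Z')
  (nu' : nat -> Z' -> option R) (tr' : nat -> trans T A D X St' Z') i j
  (p : nat -> St) (tr : nat -> trans T A D X St Z) :
  fresh_start_on Dl init -> p i = init ->
  (forall k, i <= k <= j -> In (tr k) Dl /\ tsrc (tr k) = p k /\ tdst (tr k) = p (S k) /\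
      ev_sat s k (tpred (tr k)) /\
      (forall nu, csat nu (tguard (tr' k)) -> csat (fun z => nu (g z)) (tguard (tr k))) /\
      (forall z, treset (tr' k) (g z) <-> treset (tr k) z)) ->
  follows_resets s nu' tr' i j ->
  (forall k, i <= k <= j -> csat (vshift (nu' k) (dt s k)) (tguard (tr' k))) ->
  exists nu, (forall z, nu i z = None) /\ run_segment s Dl i j p nu tr.
Proof. intros HI Hp H Hr Hg.
  exists (fun k => if Nat.leb k i then (fun _ => None) else (fun z => nu' k (g z))). split.
  { intros z. rewrite Nat.leb_refl. auto. }
  intros k Hk. destruct (H k Hk) as [H1 [H2 [H3 [H4 [H5 H6]]]]].
  refine (conj H1 (conj H2 (conj H3 (conj H4 (conj _ _))))).
  - destruct (Nat.eq_dec k i) as [E|E].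
    + subst. apply csat_clockless with (nu := fun z => vshift (nu' i) (dt s i) (g z)).
      apply (HI _ H1). congruence. apply H5. apply Hg; auto.
    + replace (Nat.leb k i) with false by (symmetry; apply Nat.leb_gt; lia).
      apply (H5 _ (Hg k Hk)).
  - intros z; split; intros Hz.
    { replace (Nat.leb (S k) i) with false by (symmetry; apply Nat.leb_gt; lia).
    apply (Hr k Hk (g z)). apply H6; auto. } replace (Nat.leb (S k) i) with false by (symmetry; apply Nat.leb_gt; lia).
    rewrite (proj2 (Hr k Hk (g z))). 2: { rewrite H6; auto. }
    destruct (Nat.eq_dec k i) as [E|E].
    + subst. exfalso. apply Hz. apply (HI _ H1). congruence.
    + replace (Nat.leb k i) with false by (symmetry; apply Nat.leb_gt; lia). reflexivity. Qed.

Lemma guard_push {St Z St' Z' : Type} s (Dl : list (trans T A D X St Z)) (init : St) (g : Z -> Z')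
  (nu' : nat -> Z' -> option R) (tr' : nat -> trans T A D X St' Z') a b
  (p : nat -> St) (nu : nat -> Z -> option R) (tr : nat -> trans T A D X St Z) :
  fresh_start_on Dl init -> p a = init -> run_segment s Dl a b p nu tr ->
  follows_resets s nu' tr' a b ->
  (forall k, a <= k <= b -> forall z, treset (tr' k) (g z) <-> treset (tr k) z) ->
  forall k, a <= k <= b -> csat (fun z => vshift (nu' k) (dt s k) (g z)) (tguard (tr k)).
Proof. intros HI Hp HS Hr Hrr k Hk.
  destruct (HS k Hk) as [H1 [H2 [H3 [H4 [H5 H6]]]]].
  destruct (Nat.eq_dec k a) as [E|E].
  - subst. eapply csat_clockless; [|exact H5]. apply (HI _ H1). congruence.
  - assert (Ha : forall z, treset (tr a) z).
    { destruct (HS a ltac:(lia)) as [G1 [G2 _]]. apply (HI _ G1). congruence. }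
    assert (Hag := @clocks_agree _ _ _ _ s nu tr nu' tr' g a b (run_segment_resets HS) Hr Hrr Ha).
    replace (fun z => vshift (nu' k) (dt s k) (g z)) with (vshift (nu k) (dt s k)); auto.
    extensionality z. unfold vshift. rewrite Hag; auto. lia. Qed.

End Part1.


Section Part2.
Variables T A D X : Type.

Lemma ev_sat_range (s : tstream T A D) k P : ev_sat s k P -> 1 <= k <= length s.
Proof. intros [e [t [H1 [H2 _]]]]. split; auto.
  assert (k - 1 < length s). { apply nth_error_Some. congruence. } lia. Qed.

Lemma ev_sat_and (s : tstream T A D) k P1 P2 : ev_sat s k (fun e => P1 e /\ P2 e) <-> ev_sat s k P1 /\ ev_sat s k P2.
Proof. unfold ev_sat; split.
  - intros [e [t [H1 [H2 [H3 H4]]]]]. split; exists e, t; auto.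
  - intros [[e [t [H1 [H2 H3]]]] [e' [t' [H1' [H2' H3']]]]]. rewrite H2 in H2'. inversion H2'; subst.
    exists e', t'; auto. Qed.

Lemma ev_sat_mono (s : tstream T A D) k (P1 P2 : Event T A D -> Prop) : (forall e, P1 e -> P2 e) -> ev_sat s k P1 -> ev_sat s k P2.
Proof. intros H [e [t [H1 [H2 H3]]]]. exists e, t; auto. Qed.

Lemma ts_step (s : tstream T A D) k : valid_stream s -> 1 <= k -> k < length s -> (ts s k < ts s (S k))%Q.
Proof. intros [_ Hv] H1 H2. destruct k. lia. cbv beta iota delta [ts].
  destruct (nth_error s k) as [[e1 t1]|] eqn:E1. 2: { apply nth_error_None in E1; lia. }
  destruct (nth_error s (S k)) as [[e2 t2]|] eqn:E2. 2: { apply nth_error_None in E2; lia. }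
  eapply Hv; eauto. Qed.

Lemma ts_lt (s : tstream T A D) a b : valid_stream s -> 1 <= a -> a < b -> b <= length s -> (ts s a < ts s b)%Q.
Proof. intros Hv Ha Hab Hb. induction b. lia.
  destruct (Nat.eq_dec a b). subst. apply ts_step; auto.
  apply Qlt_trans with (ts s b). apply IHb; lia. apply ts_step; auto; lia. Qed.

Lemma ts_le (s : tstream T A D) a b : valid_stream s -> 1 <= a -> a <= b -> b <= length s -> (ts s a <= ts s b)%Q.
Proof. intros. destruct (Nat.eq_dec a b). subst; apply Qle_refl. apply Qlt_le_weak, ts_lt; auto; lia. Qed.

End Part2.

Open Scope Q_scope.

Definition interval_guard {Z : Type} (I : interval) (z : Z) : ccond Z :=
  CAnd (if ilo_closed I then (if Qlt_le_dec 0 (ilo I) then CGe z (ilo I) else CTrue _)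
        else (if Qlt_le_dec (ilo I) 0 then CTrue _ else CGt z (ilo I)))
       (match ihi I with
        | None => CTrue _
        | Some (h, c) => if Qlt_le_dec h 0 then CLt z 0 else (if c then CLe z h else CLt z h)
        end).

Lemma interval_guard_consts {Z : Type} I (z : Z) : cconsts_nonneg (interval_guard I z).
Proof. unfold interval_guard. simpl. split.
  - destruct (ilo_closed I); [destruct (Qlt_le_dec 0 (ilo I))|destruct (Qlt_le_dec (ilo I) 0)]; simpl; auto.
    apply Qlt_le_weak; auto.
  - destruct (ihi I) as [[h c]|]; simpl; auto. destruct (Qlt_le_dec h 0); simpl. apply Qle_refl.
    destruct c; simpl; auto. Qed.

Lemma Q2R_le_iff a b : (Q2R a <= Q2R b)%R <-> a <= b.
Proof. split. apply Rle_Qle. apply Qle_Rle. Qed.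
Lemma Q2R_lt_iff a b : (Q2R a < Q2R b)%R <-> a < b.
Proof. split. apply Rlt_Qlt. apply Qlt_Rlt. Qed.

Lemma csat_interval_guard {Z : Type} (I : interval) (z : Z) (nu : Z -> option R) d :
  nu z = Some (Q2R d) -> 0 <= d -> (csat nu (interval_guard I z) <-> in_interval I d).
Proof. intros Hz Hd.
  assert (Hall : forall z', In z' (cclocks (interval_guard I z)) -> z' = z).
  { unfold interval_guard; simpl. intros z' Hin. apply in_app_iff in Hin.
    destruct (ilo_closed I); [destruct (Qlt_le_dec 0 (ilo I))|destruct (Qlt_le_dec (ilo I) 0)];
    destruct (ihi I) as [[h c]|]; try destruct (Qlt_le_dec h 0); try destruct c; simpl in Hin; intuition. }
  assert (Hdef : forall z', In z' (cclocks (interval_guard I z)) -> nu z' <> None).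
  { intros z' Hin. rewrite (Hall z' Hin), Hz. discriminate. }
  unfold csat, in_interval.
  split.
  - intros [_ HH]. unfold interval_guard in HH; simpl in HH. destruct HH as [H1 H2]. split.
    + destruct (ilo_closed I); [destruct (Qlt_le_dec 0 (ilo I))|destruct (Qlt_le_dec (ilo I) 0)]; simpl in H1.
      * destruct H1 as [v [E H1]]. rewrite Hz in E. inversion E; subst. apply Rge_le in H1. apply Rle_Qle; auto.
      * apply Qle_trans with 0; auto.
      * apply Qlt_le_trans with 0; auto.
      * destruct H1 as [v [E H1]]. rewrite Hz in E. inversion E; subst. apply Rlt_Qlt; auto.
    + destruct (ihi I) as [[h c]|]; auto. destruct (Qlt_le_dec h 0); simpl in H2.
      * destruct H2 as [v [E H2]]. rewrite Hz in E. inversion E; subst. apply Rlt_Qlt in H2.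
        exfalso. apply (Qlt_irrefl 0). apply Qle_lt_trans with d; auto.
      * destruct c; destruct H2 as [v [E H2]]; rewrite Hz in E; inversion E; subst.
        apply Rle_Qle; auto. apply Rlt_Qlt; auto.
  - intros [H1 H2]. split.
    + exact Hdef.
    + unfold interval_guard; simpl. split.
      * destruct (ilo_closed I); [destruct (Qlt_le_dec 0 (ilo I))|destruct (Qlt_le_dec (ilo I) 0)]; simpl; auto.
        exists (Q2R d); split; auto. apply Rle_ge, Qle_Rle; auto.
        exists (Q2R d); split; auto. apply Qlt_Rlt; auto.
      * destruct (ihi I) as [[h c]|]; simpl; auto. destruct (Qlt_le_dec h 0); simpl.
        -- exfalso. destruct c; [apply (Qlt_irrefl 0); apply Qle_lt_trans with d; auto; apply Qle_lt_trans with h; auto|].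
           apply (Qlt_irrefl 0). apply Qle_lt_trans with d; auto. apply Qlt_trans with h; auto.
        -- destruct c; exists (Q2R d); split; auto. apply Qle_Rle; auto. apply Qlt_Rlt; auto. Qed.

Lemma in_interval_Qeq I d d' : d == d' -> in_interval I d -> in_interval I d'.
Proof. intros E [H1 H2]. split.
  - destruct (ilo_closed I); rewrite <- E; auto.
  - destruct (ihi I) as [[h c]|]; auto. destruct c; rewrite <- E; auto. Qed.

Close Scope Q_scope.

Lemma semT_iff {T A D X : Type} (M : TCEA T A D X) s C :
  semT M s C <-> wfCE s C /\ exists p nu tr, p (cs C) = tinit M /\ (forall z, nu (cs C) z = None) /\
     run_segment s (tdelta M) (cs C) (ce C) p nu tr /\ tfinal M (p (S (ce C))) /\
     (forall x k, cmu C x k <-> (cs C <= k <= ce C /\ tlab (tr k) x)).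
Proof. unfold semT, accepting_run, run_segment. split.
  - intros [W [p [nu [tr [[H1 [H2 [H3 H4]]] H5]]]]]. split; auto. exists p, nu, tr; auto.
  - intros [W [p [nu [tr [H1 [H2 [H3 [H4 H5]]]]]]]]. split; auto. exists p, nu, tr; auto. Qed.

Definition fresh_start {T A D X : Type} (M : TCEA T A D X) := fresh_start_on (tdelta M) (tinit M).


Section Part3.
Variables T A D X : Type.
Notation TA := (TCEA T A D X).

Definition mapA (M : TA) (h : trans T A D X (tst M) (tclk M) -> trans T A D X (tst M) (tclk M)) : TA :=
  @mkTCEA T A D X (tst M) (tclk M) (tst_fin M) (tclk_fin M) (map h (tdelta M)) (tinit M) (tfinal M).

Lemma run_segment_map_inv {St Z : Type} s (Dl : list (trans T A D X St Z)) (h : trans T A D X St Z -> trans T A D X St Z) i j p nu tr' :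
  (forall t, tsrc (h t) = tsrc t /\ tdst (h t) = tdst t /\ tguard (h t) = tguard t /\ treset (h t) = treset t) ->
  (forall t e, tpred (h t) e -> tpred t e) ->
  run_segment s (map h Dl) i j p nu tr' ->
  exists tr, (forall k, i <= k <= j -> tr' k = h (tr k)) /\ run_segment s Dl i j p nu tr.
Proof. intros Hh Hp HS.
  destruct (@choice_range _ (tr' 0) (fun k t => In t Dl /\ tr' k = h t) i j) as [tr Htr].
  { intros k Hk. destruct (HS k Hk) as [H1 _]. apply in_map_iff in H1. destruct H1 as [t [E Ht]]. exists t; auto. }
  exists tr. split. intros k Hk; apply Htr; auto.
  intros k Hk. destruct (Htr k Hk) as [Hin E]. destruct (HS k Hk) as [H1 [H2 [H3 [H4 [H5 H6]]]]].
  rewrite E in *. destruct (Hh (tr k)) as [E1 [E2 [Eg E4]]]. rewrite E1, E2, Eg, E4 in *.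
  refine (conj Hin (conj H2 (conj H3 (conj _ (conj H5 H6))))). eapply ev_sat_mono; [|exact H4]. auto. Qed.

Lemma run_segment_map {St Z : Type} s (Dl : list (trans T A D X St Z)) (h : trans T A D X St Z -> trans T A D X St Z) i j p nu tr :
  (forall t, tsrc (h t) = tsrc t /\ tdst (h t) = tdst t /\ tguard (h t) = tguard t /\ treset (h t) = treset t) ->
  run_segment s Dl i j p nu tr -> (forall k, i <= k <= j -> ev_sat s k (tpred (h (tr k)))) ->
  run_segment s (map h Dl) i j p nu (fun k => h (tr k)).
Proof. intros Hh HS Hev k Hk. destruct (HS k Hk) as [H1 [H2 [H3 [H4 [H5 H6]]]]].
  destruct (Hh (tr k)) as [E1 [E2 [Eg E4]]]. rewrite E1, E2, Eg, E4.
  refine (conj (in_map _ _ _ H1) (conj H2 (conj H3 (conj (Hev k Hk) (conj H5 H6))))). Qed.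

Lemma mapA_fresh_start (M : TA) h :
  (forall t, tsrc (h t) = tsrc t /\ tdst (h t) = tdst t /\ tguard (h t) = tguard t /\ treset (h t) = treset t) ->
  fresh_start M -> fresh_start (mapA M h).
Proof. intros Hh HI t Ht Hs. simpl in *. apply in_map_iff in Ht. destruct Ht as [t0 [<- Ht0]].
  destruct (Hh t0) as [E1 [E2 [Eg E4]]]. rewrite Eg, E4. rewrite E1 in Hs. apply HI; auto. Qed.

Lemma mapA_ok (Pset : (Event T A D -> Prop) -> Prop) (M : TA) h :
  (forall t, tsrc (h t) = tsrc t /\ tdst (h t) = tdst t /\ tguard (h t) = tguard t /\ treset (h t) = treset t) ->
  (forall t, Pset (tpred t) -> Pset (tpred (h t))) ->
  tcea_ok Pset M -> tcea_ok Pset (mapA M h).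
Proof. intros Hh Hp HI t Ht. simpl in *. apply in_map_iff in Ht. destruct Ht as [t0 [<- Ht0]].
  destruct (Hh t0) as [E1 [E2 [Eg E4]]]. rewrite Eg. destruct (HI t0 Ht0); auto. Qed.

Definition relabel (F : (X -> Prop) -> X -> Prop) {St Z : Type} (t : trans T A D X St Z) :=
  mkTrans (tsrc t) (tpred t) (tguard t) (F (tlab t)) (treset t) (tdst t).

Definition relabelA F (M : TA) : TA := mapA M (relabel F).

Lemma relabelA_spec F (M : TA) s C :
  (forall L1 L2, (forall y, L1 y <-> L2 y) -> forall z, F L1 z <-> F L2 z) ->
  (forall z, ~ F (fun _ => False) z) ->
  semT (relabelA F M) s C <-> wfCE s C /\ exists C', semT M s C' /\ cs C' = cs C /\ ce C' = ce C /\
       forall z k, cmu C z k <-> F (fun y => cmu C' y k) z.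
Proof. intros Fext F0. rewrite semT_iff. split.
  - intros [W [p [nu [tr' [H1 [H2 [H3 [H4 H5]]]]]]]]. split; auto.
    destruct (@run_segment_map_inv _ _ s _ (relabel F) _ _ p nu tr' ltac:(intros; simpl; auto) ltac:(simpl; auto) H3) as [tr [Etr HS]].
    exists (mkCE (cs C) (ce C) (fun y k => cs C <= k <= ce C /\ tlab (tr k) y)). simpl.
    split; [|split; [auto|split; [auto|]]].
    + apply semT_iff. split.
      * destruct W as [W1 [W2 [W3 W4]]]. split; simpl; auto. split; auto. split; auto. intros x k [Hk _]; exact Hk.
      * exists p, nu, tr. simpl. split; [exact H1|split; [exact H2|split; [exact HS|split; [exact H4|]]]]. intros; apply iff_refl.
    + intros z k. rewrite H5. destruct (pdec (cs C <= k <= ce C)) as [Hk|Hk].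
      * rewrite Etr by auto. simpl. rewrite (Fext (fun y => cs C <= k <= ce C /\ tlab (tr k) y) (tlab (tr k))) by tauto. tauto.
      * rewrite (Fext (fun y => cs C <= k <= ce C /\ tlab (tr k) y) (fun _ => False)) by tauto. split; [tauto|]. intros HF; exfalso; eapply F0; eauto.
  - intros [W [C' [HC' [Es [Ee HL]]]]]. apply semT_iff in HC'.
    destruct HC' as [W' [p [nu [tr [H1 [H2 [H3 [H4 H5]]]]]]]]. rewrite Es, Ee in *.
    split; auto. exists p, nu, (fun k => relabel F (tr k)). split; [exact H1|split; [exact H2|split; [|split; [exact H4|]]]].
    + apply run_segment_map. intros; simpl; auto. exact H3. intros k Hk. apply H3; auto.
    + intros z k. rewrite HL. destruct (pdec (cs C <= k <= ce C)) as [Hk|Hk].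
      * simpl. rewrite (Fext (fun y => cmu C' y k) (tlab (tr k))) by (intros; rewrite H5; tauto). tauto.
      * rewrite (Fext (fun y => cmu C' y k) (fun _ => False)) by (intros; rewrite H5; tauto). split; [|tauto]. intros HF; exfalso; eapply F0; eauto.
Qed.

Definition filter_trans (x : X) (P : Event T A D -> Prop) {St Z : Type} (t : trans T A D X St Z) :=
  mkTrans (tsrc t) (if pdec (tlab t x) then (fun e => tpred t e /\ P e) else tpred t) (tguard t) (tlab t) (treset t) (tdst t).

Definition filterA x P (M : TA) : TA := mapA M (filter_trans x P).

Lemma filterA_spec x P (M : TA) s C :
  semT (filterA x P M) s C <-> semT M s C /\ forall k, cmu C x k -> ev_sat s k P.
Proof. rewrite !semT_iff. split.
  - intros [W [p [nu [tr' [H1 [H2 [H3 [H4 H5]]]]]]]].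
    destruct (@run_segment_map_inv _ _ s (tdelta M) (filter_trans x P) (cs C) (ce C) p nu tr' ltac:(intros; simpl; auto)) as [tr [Etr HS]].
    { intros t e. simpl. destruct (pdec (tlab t x)); tauto. } exact H3.
    split. split; auto. exists p, nu, tr. split; [exact H1|split; [exact H2|split; [exact HS|split; [exact H4|]]]]. intros y k. rewrite H5.
    destruct (pdec (cs C <= k <= ce C)) as [Hk|Hk]; [rewrite Etr by auto; simpl; tauto | tauto].
    intros k Hk. apply H5 in Hk. destruct Hk as [Hk Hl]. destruct (H3 k Hk) as [_ [_ [_ [Hev _]]]].
    rewrite Etr in Hev, Hl by auto. simpl in *. destruct (pdec (tlab (tr k) x)); [|contradiction].
    eapply ev_sat_mono; [|exact Hev]. simpl; tauto.
  - intros [[W [p [nu [tr [H1 [H2 [H3 [H4 H5]]]]]]]] HP].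
    split; auto. exists p, nu, (fun k => filter_trans x P (tr k)). split; [exact H1|split; [exact H2|split; [|split; [exact H4|]]]].
    + apply run_segment_map. intros; simpl; auto. exact H3. intros k Hk. simpl.
      destruct (pdec (tlab (tr k) x)) as [Hl|Hl].
      * apply ev_sat_and. split. apply H3; auto. apply HP. apply H5; auto.
      * apply H3; auto.
    + intros y k; rewrite H5; simpl; apply iff_refl.
Qed.

Lemma fin_bool : exists l : list bool, forall q, In q l.
Proof. exists [false; true]. intros []; simpl; auto. Qed.
Lemma fin_empty : exists l : list Empty_set, forall q, In q l.
Proof. exists []. intros []. Qed.

Definition atom_trans (inj : T -> X) (R0 : T) : trans T A D X bool Empty_set :=
  mkTrans false (fun e => etype e = R0) (CTrue _) (fun x => x = inj R0) (fun _ => True) true.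

Definition atomA (inj : T -> X) (R0 : T) : TA :=
  @mkTCEA T A D X bool Empty_set fin_bool fin_empty [atom_trans inj R0] false (fun b => b = true).

Lemma atomA_spec inj R0 s C :
  semT (atomA inj R0) s C <-> sem inj s (FAtom A D X R0) C.
Proof. rewrite semT_iff. split.
  - intros [W [p [nu [tr [H1 [H2 [H3 [H4 H5]]]]]]]]. simpl in *.
    assert (Hall : forall k, cs C <= k <= ce C -> tr k = atom_trans inj R0).
    { intros k Hk. destruct (H3 k Hk) as [Hin _]. simpl in Hin. destruct Hin as [E|[]]; auto. }
    assert (Ee : ce C = cs C).
    { destruct W as [W1 [W2 _]]. destruct (Nat.eq_dec (ce C) (cs C)); auto. exfalso.
      destruct (H3 (cs C) ltac:(lia)) as [_ [_ [E1 _]]]. destruct (H3 (S (cs C)) ltac:(lia)) as [_ [E2 _]].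
      rewrite !Hall in * by lia. simpl in *. congruence. }
    apply sem_atom; auto.
    + destruct (H3 (cs C) ltac:(lia)) as [_ [_ [_ [Hev _]]]]. rewrite Hall in Hev by lia. exact Hev.
    + intros x k. rewrite H5. split.
      * intros [Hk Hl]. rewrite Hall in Hl by auto. simpl in Hl. split; auto; lia.
      * intros [-> ->]. split. lia. rewrite Hall by lia. simpl; auto.
  - intros H. inversion H; subst. split; auto.
    exists (fun k => if Nat.leb k (cs C) then false else true), (fun _ _ => None), (fun _ => atom_trans inj R0).
    rewrite Nat.leb_refl. split; auto. split; auto. split; [|split].
    + intros k Hk. assert (k = cs C) by lia. subst k.
      assert (E1: Nat.leb (cs C) (cs C) = true) by apply Nat.leb_refl.
      assert (E2: Nat.leb (S (cs C)) (cs C) = false) by (apply Nat.leb_gt; lia).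
      cbv beta. rewrite E1, E2.
      refine (conj (or_introl eq_refl) (conj eq_refl (conj eq_refl (conj _ (conj _ _))))).
      * exact H3.
      * split; [intros z []|exact I].
      * intros z; destruct z.
    + replace (Nat.leb (S (ce C)) (cs C)) with false by (symmetry; apply Nat.leb_gt; lia). reflexivity.
    + intros x k. rewrite H4. simpl. split. intros [-> ->]; split; auto; lia. intros [Hk ->]; split; auto; lia.
Qed.

Lemma atomA_fresh_start inj R0 : fresh_start (atomA inj R0).
Proof. intros t Ht _. simpl in Ht. destruct Ht as [<-|[]]. simpl. split; auto. Qed.

Lemma atomA_ok (Pset : (Event T A D -> Prop) -> Prop) inj R0 :
  Pset (fun e => etype e = R0) -> tcea_ok Pset (atomA inj R0).
Proof. intros HP t Ht. simpl in Ht. destruct Ht as [<-|[]]. simpl. auto. Qed.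

End Part3.


Section Part4.
Variables T A D X : Type.
Notation TA := (TCEA T A D X).

Definition idle_trans (M : TA) : trans T A D X (tst M) (tclk M) :=
  mkTrans (tinit M) (fun _ => True) (CTrue _) (fun _ => False) (fun _ => False) (tinit M).

Definition sum_reset {Z1 Z2 : Type} (r1 : Z1 -> Prop) (r2 : Z2 -> Prop) : Z1 + Z2 -> Prop :=
  fun z => match z with inl a => r1 a | inr b => r2 b end.

Definition prod_trans {S1 Z1 S2 Z2 : Type} (t1 : trans T A D X S1 Z1) (t2 : trans T A D X S2 Z2)
  : trans T A D X (S1 * S2) (Z1 + Z2) :=
  mkTrans (tsrc t1, tsrc t2) (fun e => tpred t1 e /\ tpred t2 e)
    (CAnd (cmap inl (tguard t1)) (cmap inr (tguard t2))) (tlab t1)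
    (sum_reset (treset t1) (treset t2)) (tdst t1, tdst t2).

Lemma fin_prod {S1 S2 : Type} : (exists l : list S1, forall q, In q l) -> (exists l : list S2, forall q, In q l) ->
  exists l : list (S1 * S2), forall q, In q l.
Proof. intros [l1 H1] [l2 H2]. exists (list_prod l1 l2). intros [a b]. apply in_prod; auto. Qed.

Lemma fin_sum {S1 S2 : Type} : (exists l : list S1, forall q, In q l) -> (exists l : list S2, forall q, In q l) ->
  exists l : list (S1 + S2), forall q, In q l.
Proof. intros [l1 H1] [l2 H2]. exists (map inl l1 ++ map inr l2). intros [a|b]; apply in_app_iff.
  left; apply in_map; auto. right; apply in_map; auto. Qed.

Lemma fin_option {S1 : Type} : (exists l : list S1, forall q, In q l) -> exists l : list (option S1), forall q, In q l.
Proof. intros [l1 H1]. exists (None :: map Some l1). intros [a|]; simpl; auto. right; apply in_map; auto. Qed.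

Definition and_delta (Mf Mg : TA) :=
  flat_map (fun t1 => flat_map (fun t2 => list_if (forall x, tlab t1 x <-> tlab t2 x) (prod_trans t1 t2)) (tdelta Mg)) (tdelta Mf).

Definition andA (Mf Mg : TA) : TA :=
  @mkTCEA T A D X (tst Mf * tst Mg) (tclk Mf + tclk Mg) (fin_prod (tst_fin Mf) (tst_fin Mg))
    (fin_sum (tclk_fin Mf) (tclk_fin Mg)) (and_delta Mf Mg) (tinit Mf, tinit Mg)
    (fun q => tfinal Mf (fst q) /\ tfinal Mg (snd q)).

Lemma in_and_delta (Mf Mg : TA) t : In t (and_delta Mf Mg) <->
  exists t1 t2, In t1 (tdelta Mf) /\ In t2 (tdelta Mg) /\ (forall x, tlab t1 x <-> tlab t2 x) /\ t = prod_trans t1 t2.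
Proof. unfold and_delta. rewrite in_flat_map. split.
  - intros [t1 [H1 H2]]. rewrite in_flat_map in H2. destruct H2 as [t2 [H2 H3]]. apply in_list_if in H3.
    exists t1, t2; tauto.
  - intros [t1 [t2 [H1 [H2 [H3 ->]]]]]. exists t1. split; auto. apply in_flat_map. exists t2. split; auto.
    apply in_list_if; auto. Qed.

Lemma andA_fresh_start (Mf Mg : TA) : fresh_start Mf -> fresh_start Mg -> fresh_start (andA Mf Mg).
Proof. intros H1 H2 t Ht Hs. simpl in *. apply in_and_delta in Ht. destruct Ht as [t1 [t2 [G1 [G2 [_ ->]]]]].
  simpl in Hs. inversion Hs. destruct (H1 t1 G1 H0) as [R1 C1]. destruct (H2 t2 G2 H3) as [R2 C2].
  simpl. split. intros [a|b]; simpl; auto. rewrite !cclocks_cmap, C1, C2. reflexivity. Qed.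

Lemma andA_ok Pset (Mf Mg : TA) :
  (forall P1 P2, Pset P1 -> Pset P2 -> Pset (fun e => P1 e /\ P2 e)) ->
  tcea_ok Pset Mf -> tcea_ok Pset Mg -> tcea_ok Pset (andA Mf Mg).
Proof. intros Hi H1 H2 t Ht. simpl in Ht. apply in_and_delta in Ht. destruct Ht as [t1 [t2 [G1 [G2 [_ ->]]]]].
  destruct (H1 t1 G1), (H2 t2 G2). simpl. split; auto. split; apply cconsts_cmap; auto. Qed.

Lemma andA_spec (Mf Mg : TA) s C : fresh_start Mf -> fresh_start Mg ->
  semT (andA Mf Mg) s C <-> semT Mf s C /\ semT Mg s C.
Proof. intros If Ig. rewrite !semT_iff. split.
  - intros [W [p [nu [tr' [H1 [H2 [H3 [H4 H5]]]]]]]].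
    destruct (@choice_range _ (idle_trans Mf, idle_trans Mg) (fun k tt => exists t1 t2, tt = (t1, t2) /\ In t1 (tdelta Mf) /\ In t2 (tdelta Mg) /\
        (forall x, tlab t1 x <-> tlab t2 x) /\ tr' k = prod_trans t1 t2) (cs C) (ce C)) as [o Ho].
    { intros k Hk. destruct (H3 k Hk) as [Hin _]. apply in_and_delta in Hin. destruct Hin as [t1 [t2 HH]].
      exists (t1, t2), t1, t2; tauto. }
    assert (Hc : forall k, cs C <= k <= ce C -> In (fst (o k)) (tdelta Mf) /\ In (snd (o k)) (tdelta Mg) /\
        (forall x, tlab (fst (o k)) x <-> tlab (snd (o k)) x) /\ tr' k = prod_trans (fst (o k)) (snd (o k))).
    { intros k Hk. destruct (Ho k Hk) as [t1 [t2 [E HH]]]. rewrite E; simpl; auto. }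
    split.
    + split; auto.
      destruct (@run_pullback T A D X _ _ _ _ s (tdelta Mf) (tinit Mf) inl nu tr' (cs C) (ce C) (fun k => fst (p k)) (fun k => fst (o k)) If)
        as [nu1 [N1 S1]].
      * rewrite H1; reflexivity.
      * intros k Hk. destruct (Hc k Hk) as [G1 [G2 [Gd G4]]]. destruct (H3 k Hk) as [_ [E1 [E2 [Ev _]]]].
        rewrite G4 in E1, E2, Ev. simpl in *. rewrite <- E1, <- E2. split; auto. split; auto. split; auto.
        split. eapply ev_sat_mono; [|exact Ev]. simpl; tauto.
        split. intros nu0 Hg. rewrite G4 in Hg. simpl in Hg. apply csat_and in Hg. apply csat_cmap. tauto.
        intros z. rewrite G4. simpl. tauto.
      * eapply run_segment_resets; eauto.
      * intros k Hk. apply H3; auto.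
      * exists (fun k => fst (p k)), nu1, (fun k => fst (o k)). split. rewrite H1; reflexivity.
        split; auto. split; auto. split. apply H4.
        intros x k. rewrite H5. destruct (pdec (cs C <= k <= ce C)) as [Hk|Hk]; [|tauto].
        destruct (Hc k Hk) as [_ [_ [_ G4]]]. rewrite G4. simpl. tauto.
    + split; auto.
      destruct (@run_pullback T A D X _ _ _ _ s (tdelta Mg) (tinit Mg) inr nu tr' (cs C) (ce C) (fun k => snd (p k)) (fun k => snd (o k)) Ig)
        as [nu1 [N1 S1]].
      * rewrite H1; reflexivity.
      * intros k Hk. destruct (Hc k Hk) as [G1 [G2 [Gd G4]]]. destruct (H3 k Hk) as [_ [E1 [E2 [Ev _]]]].
        rewrite G4 in E1, E2, Ev. simpl in *. rewrite <- E1, <- E2. split; auto. split; auto. split; auto.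
        split. eapply ev_sat_mono; [|exact Ev]. simpl; tauto.
        split. intros nu0 Hg. rewrite G4 in Hg. simpl in Hg. apply csat_and in Hg. apply csat_cmap. tauto.
        intros z. rewrite G4. simpl. tauto.
      * eapply run_segment_resets; eauto.
      * intros k Hk. apply H3; auto.
      * exists (fun k => snd (p k)), nu1, (fun k => snd (o k)). split. rewrite H1; reflexivity.
        split; auto. split; auto. split. apply H4.
        intros x k. rewrite H5. destruct (pdec (cs C <= k <= ce C)) as [Hk|Hk]; [|tauto].
        destruct (Hc k Hk) as [_ [_ [Gd G4]]]. rewrite G4. simpl. rewrite Gd. tauto.
  - intros [[W [p1 [nu1 [tr1 [H1 [H2 [H3 [H4 H5]]]]]]]] [_ [p2 [nu2 [tr2 [K1 [K2 [K3 [K4 K5]]]]]]]]].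
    split; auto.
    set (tr' := fun k => prod_trans (tr1 k) (tr2 k)).
    set (nu' := run_val s (fun _ : tclk Mf + tclk Mg => None) tr' (cs C)).
    assert (Hr : follows_resets s nu' tr' (cs C) (ce C)) by apply run_val_resets.
    exists (fun k => (p1 k, p2 k)), nu', tr'. split. simpl; rewrite H1, K1; reflexivity.
    split. intros z. unfold nu'. rewrite run_val_start. reflexivity.
    split; [|split; [simpl; auto|]].
    + intros k Hk. destruct (H3 k Hk) as [G1 [G2 [Gd [G4 _]]]]. destruct (K3 k Hk) as [L1 [L2 [L3 [L4 _]]]].
      split. apply in_and_delta. exists (tr1 k), (tr2 k). split; auto. split; auto. split; auto.
      intros x. pose proof (H5 x k). pose proof (K5 x k). tauto.
      split. simpl. rewrite G2, L2; auto. split. simpl. rewrite Gd, L3; auto.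
      split. apply ev_sat_and; auto.
      split. simpl. apply csat_and. split; apply csat_cmap.
      * apply (@guard_push T A D X _ _ _ _ s (tdelta Mf) (tinit Mf) inl nu' tr' (cs C) (ce C) p1 nu1 tr1); auto.
        intros; simpl; tauto.
      * apply (@guard_push T A D X _ _ _ _ s (tdelta Mg) (tinit Mg) inr nu' tr' (cs C) (ce C) p2 nu2 tr2); auto.
        intros; simpl; tauto.
      * apply Hr; auto.
    + intros x k. rewrite H5. simpl. tauto.
Qed.

End Part4.


Section Part5.
Variables T A D X : Type.
Notation TA := (TCEA T A D X).

Definition simulates {St Z St' Z' : Type} (lastD : trans T A D X St' Z' -> trans T A D X St Z -> Prop) (init : St) (sg : St -> St') (zt : Z -> Z') (a b k : nat)
  (t' : trans T A D X St' Z') (t0 : trans T A D X St Z) : Prop :=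
  (forall e, tpred t' e -> tpred t0 e) /\ (forall x, tlab t' x <-> tlab t0 x) /\
  (forall nu, csat nu (tguard t') -> csat (fun z => nu (zt z)) (tguard t0)) /\
  (forall z, treset t' (zt z) <-> treset t0 z) /\
  (k = a -> tsrc t0 = init) /\ (a < k -> tsrc t' = sg (tsrc t0)) /\ (k < b -> tdst t' = sg (tdst t0)) /\ (k = b -> lastD t' t0).

Lemma run_segment_pull {St Z St' Z' : Type} s (Dl : list (trans T A D X St Z)) (init : St) (dt0 : trans T A D X St Z)
  (sg : St -> St') (zt : Z -> Z') (lastD : trans T A D X St' Z' -> trans T A D X St Z -> Prop) (Dl' : list (trans T A D X St' Z')) a b p' nu' tr' :
  fresh_start_on Dl init -> (forall q1 q2, sg q1 = sg q2 -> q1 = q2) -> a <= b ->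
  run_segment s Dl' a b p' nu' tr' ->
  (forall k, a <= k <= b -> exists t0, In t0 Dl /\ simulates lastD init sg zt a b k (tr' k) t0) ->
  exists p nu tr, p a = init /\ (forall z, nu a z = None) /\ run_segment s Dl a b p nu tr /\
    p (S b) = tdst (tr b) /\ (forall k, a <= k <= b -> In (tr k) Dl /\ simulates lastD init sg zt a b k (tr' k) (tr k)).
Proof. intros HI Hinj Hab HS H.
  destruct (@choice_range _ dt0 (fun k t0 => In t0 Dl /\ simulates lastD init sg zt a b k (tr' k) t0) a b H) as [tr Htr].
  set (p := fun k => if Nat.leb k b then tsrc (tr k) else tdst (tr b)).
  assert (Hpa : p a = init).
  { unfold p. destruct (Nat.leb_spec0 a b); [|lia]. destruct (Htr a (conj (le_n a) Hab)) as [_ [_ [_ [_ [_ [E _]]]]]]. auto. }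
  destruct (@run_pullback T A D X _ _ _ _ s Dl init zt nu' tr' a b p tr HI Hpa) as [nu [N1 S1]].
  - intros k Hk. destruct (Htr k Hk) as [Hin [C1 [C2 [C3 [C4 [C5 [C6 [C7 C8]]]]]]]].
    destruct (HS k Hk) as [G1 [G2 [Gd [G4 _]]]].
    split; auto. split. unfold p. destruct (Nat.leb_spec0 k b); [auto|lia].
    split. unfold p. destruct (Nat.leb_spec0 (S k) b).
    + destruct (Htr (S k) ltac:(lia)) as [_ [_ [_ [_ [_ [_ [D6 _]]]]]]].
      apply Hinj. rewrite <- C7 by lia. rewrite <- D6 by lia. rewrite Gd.
      destruct (HS (S k) ltac:(lia)) as [_ [F2 _]]. auto.
    + assert (k = b) by lia. subst; auto.
    + split. eapply ev_sat_mono; [|exact G4]. auto. split; auto.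
  - eapply run_segment_resets; eauto.
  - intros k Hk. apply HS; auto.
  - exists p, nu, tr. split; auto. split; auto. split; auto. split.
    unfold p. destruct (Nat.leb_spec0 (S b) b); [lia|auto]. auto.
Qed.

Lemma run_segment_push {St Z St' Z' : Type} s (Dl : list (trans T A D X St Z)) (init : St)
  (zt : Z -> Z') (Dl' : list (trans T A D X St' Z')) a b (p : nat -> St) (nu : nat -> Z -> option R)
  (tr : nat -> trans T A D X St Z) (p' : nat -> St') (nu' : nat -> Z' -> option R) (tr' : nat -> trans T A D X St' Z') :
  fresh_start_on Dl init -> run_segment s Dl a b p nu tr -> p a = init -> follows_resets s nu' tr' a b ->
  (forall k, a <= k <= b -> In (tr' k) Dl' /\ tsrc (tr' k) = p' k /\ tdst (tr' k) = p' (S k) /\ (forall e, tpred (tr k) e -> tpred (tr' k) e) /\ (forall z, treset (tr' k) (zt z) <-> treset (tr k) z) /\ (csat (fun z => vshift (nu' k) (dt s k) (zt z)) (tguard (tr k)) -> csat (vshift (nu' k) (dt s k)) (tguard (tr' k)))) ->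
  run_segment s Dl' a b p' nu' tr'.
Proof. intros HI HS Hp Hr H k Hk. destruct (H k Hk) as [G1 [G2 [Gd [G4 [G5 G6]]]]].
  split; auto. split; auto. split; auto. split.
  - eapply ev_sat_mono; [exact G4|]. apply HS; auto.
  - split. apply G6. eapply (@guard_push T A D X _ _ _ _ s Dl init zt nu' tr' a b p nu tr); eauto.
    intros; apply H; auto.
    apply Hr; auto. Qed.

End Part5.


Section Part6.
Variables T A D X : Type.
Notation TA := (TCEA T A D X).

Definition embed_trans {S1 Z1 S2 Z2 : Type} (fs : S1 -> S2) (fz : Z1 -> Z2) (res : (Z1 -> Prop) -> Z2 -> Prop)
  (t : trans T A D X S1 Z1) : trans T A D X S2 Z2 :=
  mkTrans (fs (tsrc t)) (tpred t) (cmap fz (tguard t)) (tlab t) (res (treset t)) (fs (tdst t)).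
Definition start_trans {S1 Z1 S2 Z2 : Type} (src : S2) (fs : S1 -> S2) (fz : Z1 -> Z2) (t : trans T A D X S1 Z1)
  : trans T A D X S2 Z2 :=
  mkTrans src (tpred t) (cmap fz (tguard t)) (tlab t) (fun _ => True) (fs (tdst t)).

Definition inl_st {S1 S2 : Type} (q : S1) : option (S1 + S2) := Some (inl q).
Definition inr_st {S1 S2 : Type} (q : S2) : option (S1 + S2) := Some (inr q).
Definition inl_reset {Z1 Z2 : Type} (r : Z1 -> Prop) : Z1 + Z2 -> Prop := sum_reset r (fun _ => False).
Definition inr_reset {Z1 Z2 : Type} (r : Z2 -> Prop) : Z1 + Z2 -> Prop := sum_reset (fun _ => False) r.

Definition or_delta (Mf Mg : TA) : list (trans T A D X (option (tst Mf + tst Mg)) (tclk Mf + tclk Mg)) :=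
  map (embed_trans inl_st inl inl_reset) (tdelta Mf) ++ flat_map (fun t => list_if (tsrc t = tinit Mf) (start_trans None inl_st inl t)) (tdelta Mf) ++
  map (embed_trans inr_st inr inr_reset) (tdelta Mg) ++ flat_map (fun t => list_if (tsrc t = tinit Mg) (start_trans None inr_st inr t)) (tdelta Mg).

Definition or_final (Mf Mg : TA) (q : option (tst Mf + tst Mg)) : Prop :=
  match q with Some (inl a) => tfinal Mf a | Some (inr b) => tfinal Mg b | None => False end.

Definition orA (Mf Mg : TA) : TA :=
  @mkTCEA T A D X (option (tst Mf + tst Mg)) (tclk Mf + tclk Mg)
    (fin_option (fin_sum (tst_fin Mf) (tst_fin Mg))) (fin_sum (tclk_fin Mf) (tclk_fin Mg))
    (or_delta Mf Mg) None (or_final Mf Mg).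

Lemma in_or_delta (Mf Mg : TA) t : In t (or_delta Mf Mg) <->
  (exists t0, In t0 (tdelta Mf) /\ t = embed_trans inl_st inl inl_reset t0) \/
  (exists t0, In t0 (tdelta Mf) /\ tsrc t0 = tinit Mf /\ t = start_trans None inl_st inl t0) \/
  (exists t0, In t0 (tdelta Mg) /\ t = embed_trans inr_st inr inr_reset t0) \/
  (exists t0, In t0 (tdelta Mg) /\ tsrc t0 = tinit Mg /\ t = start_trans None inr_st inr t0).
Proof. unfold or_delta. rewrite !in_app_iff, !in_flat_map, !in_map_iff. split.
  - intros [[t0 [E H]]|[[t0 [H E]]|[[t0 [E H]]|[t0 [H E]]]]].
    + left; exists t0; auto.
    + apply in_list_if in E. right; left; exists t0; destruct E; subst; auto.
    + right; right; left; exists t0; auto.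
    + apply in_list_if in E. right; right; right; exists t0; destruct E; subst; auto.
  - intros [[t0 [H E]]|[[t0 [H [E1 E]]]|[[t0 [H E]]|[t0 [H [E1 E]]]]]].
    + left; exists t0; auto.
    + right; left; exists t0; split; auto. apply in_list_if; auto.
    + right; right; left; exists t0; auto.
    + right; right; right; exists t0; split; auto. apply in_list_if; auto. Qed.

Lemma orA_fresh_start (Mf Mg : TA) : fresh_start Mf -> fresh_start Mg -> fresh_start (orA Mf Mg).
Proof. intros H1 H2 t Ht Hs. simpl in *. apply in_or_delta in Ht.
  destruct Ht as [[t0 [G ->]]|[[t0 [G [E ->]]]|[[t0 [G ->]]|[t0 [G [E ->]]]]]]; simpl in *; try discriminate.
  - split; auto. rewrite cclocks_cmap, (proj2 (H1 t0 G E)); auto.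
  - split; auto. rewrite cclocks_cmap, (proj2 (H2 t0 G E)); auto. Qed.

Lemma orA_ok Pset (Mf Mg : TA) : tcea_ok Pset Mf -> tcea_ok Pset Mg -> tcea_ok Pset (orA Mf Mg).
Proof. intros H1 H2 t Ht. simpl in Ht. apply in_or_delta in Ht.
  destruct Ht as [[t0 [G ->]]|[[t0 [G [E ->]]]|[[t0 [G ->]]|[t0 [G [E ->]]]]]]; simpl;
  [destruct (H1 t0 G)|destruct (H1 t0 G)|destruct (H2 t0 G)|destruct (H2 t0 G)]; split; auto; apply cconsts_cmap; auto. Qed.

Lemma orA_spec (Mf Mg : TA) s C : fresh_start Mf -> fresh_start Mg ->
  semT (orA Mf Mg) s C <-> semT Mf s C \/ semT Mg s C.
Proof. intros If Ig. rewrite !semT_iff. split.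
  - intros [W [p' [nu' [tr' [H1 [H2 [H3 [H4 H5]]]]]]]].
    assert (Wl : cs C <= ce C) by apply W.
    destruct (H3 (cs C) ltac:(lia)) as [G1 [G2 [Gd _]]]. simpl in H1. rewrite H1 in G2.
    apply in_or_delta in G1. destruct G1 as [[t0 [G E']]|[[t0 [G [E E']]]|[[t0 [G E']]|[t0 [G [E E']]]]]];
      rewrite E' in G2; simpl in G2; try discriminate.
    +
      left. split; auto.
      assert (Cl : forall k, cs C < k <= S (ce C) -> exists a, p' k = inl_st a).
      { intros k Hk. induction k. lia. destruct (Nat.eq_dec k (cs C)) as [->|Ne].
        - exists (tdst t0). rewrite <- Gd, E'. reflexivity.
        - destruct IHk as [a Ha]. lia. destruct (H3 k ltac:(lia)) as [K1 [K2 [K3 _]]].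
          rewrite Ha in K2. apply in_or_delta in K1.
          destruct K1 as [[t1 [_ E1]]|[[t1 [_ [_ E1]]]|[[t1 [_ E1]]|[t1 [_ [_ E1]]]]]]; rewrite E1 in K2, K3; simpl in K2;
            try discriminate. exists (tdst t1). rewrite <- K3. reflexivity. }
      destruct (@run_segment_pull T A D X _ _ _ _ s (tdelta Mf) (tinit Mf) (idle_trans Mf) inl_st inl (fun t' t0 => tdst t' = inl_st (tdst t0)) (or_delta Mf Mg) (cs C) (ce C) p' nu' tr'
        If ltac:(intros q1 q2 Eq; inversion Eq; auto) Wl H3) as [p [nu [tr [P1 [P2 [P3 [P4 P5]]]]]]].
      { intros k Hk. destruct (Nat.eq_dec k (cs C)) as [->|Ne].
        - exists t0. split; auto. rewrite E'. unfold simulates; simpl.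
          split; auto. split; [tauto|]. split. intros nu0 Hc; apply csat_cmap; auto.
          split. intros z; split; auto; intros _; apply (If t0 G E). split; auto. split. lia. split; auto.
        - destruct (Cl k ltac:(lia)) as [a Ha]. destruct (H3 k Hk) as [K1 [K2 _]]. rewrite Ha in K2.
          apply in_or_delta in K1.
          destruct K1 as [[t1 [T1 E1]]|[[t1 [_ [_ E1]]]|[[t1 [_ E1]]|[t1 [_ [_ E1]]]]]]; rewrite E1 in K2; simpl in K2;
            try discriminate.
          exists t1. split; auto. rewrite E1. unfold simulates; simpl.
          split; auto. split; [tauto|]. split. intros nu0 Hc; apply csat_cmap; auto.
          split. intros z; simpl; tauto. split. lia. repeat split; auto. }
      exists p, nu, tr. split; auto. split; auto. split; auto. split.
      * destruct (P5 (ce C) ltac:(lia)) as [_ [_ [_ [_ [_ [_ [_ [_ Q]]]]]]]].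
        destruct (H3 (ce C) ltac:(lia)) as [_ [_ [K3 _]]].
        assert (Q' : p' (S (ce C)) = inl_st (tdst (tr (ce C)))) by (rewrite <- K3; exact (Q eq_refl)).
        rewrite P4. rewrite Q' in H4. exact H4.
      * intros x k. rewrite H5. destruct (pdec (cs C <= k <= ce C)) as [Hk|Hk]; [|tauto].
        destruct (P5 k Hk) as [_ [_ [Q _]]]. rewrite Q. tauto.
    +
      right. split; auto.
      assert (Cl : forall k, cs C < k <= S (ce C) -> exists a, p' k = inr_st a).
      { intros k Hk. induction k. lia. destruct (Nat.eq_dec k (cs C)) as [->|Ne].
        - exists (tdst t0). rewrite <- Gd, E'. reflexivity.
        - destruct IHk as [a Ha]. lia. destruct (H3 k ltac:(lia)) as [K1 [K2 [K3 _]]].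
          rewrite Ha in K2. apply in_or_delta in K1.
          destruct K1 as [[t1 [_ E1]]|[[t1 [_ [_ E1]]]|[[t1 [_ E1]]|[t1 [_ [_ E1]]]]]]; rewrite E1 in K2, K3; simpl in K2;
            try discriminate. exists (tdst t1). rewrite <- K3. reflexivity. }
      destruct (@run_segment_pull T A D X _ _ _ _ s (tdelta Mg) (tinit Mg) (idle_trans Mg) inr_st inr (fun t' t0 => tdst t' = inr_st (tdst t0)) (or_delta Mf Mg) (cs C) (ce C) p' nu' tr'
        Ig ltac:(intros q1 q2 Eq; inversion Eq; auto) Wl H3) as [p [nu [tr [P1 [P2 [P3 [P4 P5]]]]]]].
      { intros k Hk. destruct (Nat.eq_dec k (cs C)) as [->|Ne].
        - exists t0. split; auto. rewrite E'. unfold simulates; simpl.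
          split; auto. split; [tauto|]. split. intros nu0 Hc; apply csat_cmap; auto.
          split. intros z; split; auto; intros _; apply (Ig t0 G E). split; auto. split. lia. split; auto.
        - destruct (Cl k ltac:(lia)) as [a Ha]. destruct (H3 k Hk) as [K1 [K2 _]]. rewrite Ha in K2.
          apply in_or_delta in K1.
          destruct K1 as [[t1 [T1 E1]]|[[t1 [_ [_ E1]]]|[[t1 [T1 E1]]|[t1 [_ [_ E1]]]]]]; rewrite E1 in K2; simpl in K2;
            try discriminate.
          exists t1. split; auto. rewrite E1. unfold simulates; simpl.
          split; auto. split; [tauto|]. split. intros nu0 Hc; apply csat_cmap; auto.
          split. intros z; simpl; tauto. split. lia. repeat split; auto. }
      exists p, nu, tr. split; auto. split; auto. split; auto. split.
      * destruct (P5 (ce C) ltac:(lia)) as [_ [_ [_ [_ [_ [_ [_ [_ Q]]]]]]]].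
        destruct (H3 (ce C) ltac:(lia)) as [_ [_ [K3 _]]].
        assert (Q' : p' (S (ce C)) = inr_st (tdst (tr (ce C)))) by (rewrite <- K3; exact (Q eq_refl)).
        rewrite P4. rewrite Q' in H4. exact H4.
      * intros x k. rewrite H5. destruct (pdec (cs C <= k <= ce C)) as [Hk|Hk]; [|tauto].
        destruct (P5 k Hk) as [_ [_ [Q _]]]. rewrite Q. tauto.
  - intros [[W [p [nu [tr [H1 [H2 [H3 [H4 H5]]]]]]]]|[W [p [nu [tr [H1 [H2 [H3 [H4 H5]]]]]]]]]; split; auto; assert (Wl : cs C <= ce C) by apply W.
    + set (tr' := fun k => if Nat.eqb k (cs C) then start_trans None inl_st inl (tr k) else embed_trans inl_st inl inl_reset (tr k)
                 : trans T A D X (option (tst Mf + tst Mg)) (tclk Mf + tclk Mg)).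
      set (p' := fun k => if Nat.leb k (cs C) then None else inl_st (p k) : option (tst Mf + tst Mg)).
      set (nu' := run_val s (fun _ : tclk Mf + tclk Mg => None) tr' (cs C)).
      exists p', nu', tr'. split. unfold p'; rewrite Nat.leb_refl; reflexivity.
      split. intros z; unfold nu'; rewrite run_val_start; auto.
      split; [|split].
      * apply (@run_segment_push T A D X _ _ _ _ s (tdelta Mf) (tinit Mf) inl _ _ _ p nu tr); auto. apply run_val_resets.
        intros k Hk. destruct (H3 k Hk) as [G1 [G2 [Gd _]]]. unfold tr', p'.
        destruct (Nat.eqb_spec k (cs C)) as [Ek|Ek].
        -- subst k. rewrite Nat.leb_refl. destruct (Nat.leb_spec0 (S (cs C)) (cs C)); [lia|].
           split. apply in_or_delta. right; left. exists (tr (cs C)). split; auto. split; auto. congruence.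
           simpl. split; auto. split. rewrite Gd; auto. split; auto. split.
           intros z; split; auto; intros _. apply (If _ G1). congruence.
           intros Hc; apply csat_cmap; auto.
        -- destruct (Nat.leb_spec0 k (cs C)); [lia|]. destruct (Nat.leb_spec0 (S k) (cs C)); [lia|].
           split. apply in_or_delta. left. exists (tr k). split; auto.
           simpl. split. rewrite G2; auto. split. rewrite Gd; auto. split; auto. split.
           intros z; simpl; tauto. intros Hc; apply csat_cmap; auto.
      * unfold p'. destruct (Nat.leb_spec0 (S (ce C)) (cs C)); [lia|]. exact H4.
      * intros x k. rewrite H5. unfold tr'. destruct (Nat.eqb k (cs C)); simpl; tauto.
    + set (tr' := fun k => if Nat.eqb k (cs C) then start_trans None inr_st inr (tr k) else embed_trans inr_st inr inr_reset (tr k)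
                 : trans T A D X (option (tst Mf + tst Mg)) (tclk Mf + tclk Mg)).
      set (p' := fun k => if Nat.leb k (cs C) then None else inr_st (p k) : option (tst Mf + tst Mg)).
      set (nu' := run_val s (fun _ : tclk Mf + tclk Mg => None) tr' (cs C)).
      exists p', nu', tr'. split. unfold p'; rewrite Nat.leb_refl; reflexivity.
      split. intros z; unfold nu'; rewrite run_val_start; auto.
      split; [|split].
      * apply (@run_segment_push T A D X _ _ _ _ s (tdelta Mg) (tinit Mg) inr _ _ _ p nu tr); auto. apply run_val_resets.
        intros k Hk. destruct (H3 k Hk) as [G1 [G2 [Gd _]]]. unfold tr', p'.
        destruct (Nat.eqb_spec k (cs C)) as [Ek|Ek].
        -- subst k. rewrite Nat.leb_refl. destruct (Nat.leb_spec0 (S (cs C)) (cs C)); [lia|].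
           split. apply in_or_delta. right; right; right. exists (tr (cs C)). split; auto. split; auto. congruence.
           simpl. split; auto. split. rewrite Gd; auto. split; auto. split.
           intros z; split; auto; intros _. apply (Ig _ G1). congruence.
           intros Hc; apply csat_cmap; auto.
        -- destruct (Nat.leb_spec0 k (cs C)); [lia|]. destruct (Nat.leb_spec0 (S k) (cs C)); [lia|].
           split. apply in_or_delta. right; right; left. exists (tr k). split; auto.
           simpl. split. rewrite G2; auto. split. rewrite Gd; auto. split; auto. split.
           intros z; simpl; tauto. intros Hc; apply csat_cmap; auto.
      * unfold p'. destruct (Nat.leb_spec0 (S (ce C)) (cs C)); [lia|]. exact H4.
      * intros x k. rewrite H5. unfold tr'. destruct (Nat.eqb k (cs C)); simpl; tauto.
Qed.

End Part6.


Inductive iter_state (S : Type) : Type := ItInit | ItGap | ItIn (q : S).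
Arguments ItInit {S}. Arguments ItGap {S}. Arguments ItIn {S} q.

Lemma fin_iter_state {S : Type} : (exists l : list S, forall q, In q l) -> exists l : list (iter_state S), forall q, In q l.
Proof. intros [l H]. exists (ItInit :: ItGap :: map ItIn l). intros [| |q]; simpl; auto. right; right; apply in_map; auto. Qed.

Definition some_reset {Z : Type} (r : Z -> Prop) : option Z -> Prop := fun z => match z with Some a => r a | None => False end.

Lemma Qsub_ge0 a b : (a <= b)%Q -> (0 <= b - a)%Q.
Proof. intros H; apply (proj1 (Qle_minus_iff a b)); auto. Qed.

Section Part7.
Variables T A D X : Type.
Notation TA := (TCEA T A D X).
Variable M : TA.
Variable I : interval.
Notation TrM := (trans T A D X (tst M) (tclk M)).
Notation TrW := (trans T A D X (iter_state (tst M)) (option (tclk M))).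

Definition win_step (t : TrM) : TrW := embed_trans ItIn Some some_reset t.
Definition win_start (t : TrM) : TrW := start_trans ItInit ItIn Some t.
Definition win_last (t : TrM) : TrW :=
  mkTrans (ItIn (tsrc t)) (tpred t) (CAnd (cmap Some (tguard t)) (interval_guard I None)) (tlab t) (some_reset (treset t)) ItGap.
Definition win_single (t : TrM) : TrW :=
  mkTrans ItInit (tpred t) (cmap Some (tguard t)) (tlab t) (fun _ => True) ItGap.

Definition win_delta : list TrW :=
  map win_step (tdelta M) ++ flat_map (fun t => list_if (tsrc t = tinit M) (win_start t)) (tdelta M) ++
  flat_map (fun t => list_if (tfinal M (tdst t)) (win_last t)) (tdelta M) ++
  flat_map (fun t => list_if (tsrc t = tinit M /\ tfinal M (tdst t) /\ in_interval I 0%Q) (win_single t)) (tdelta M).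

Definition winA : TA :=
  @mkTCEA T A D X (iter_state (tst M)) (option (tclk M)) (fin_iter_state (tst_fin M)) (fin_option (tclk_fin M))
    win_delta ItInit (fun q => q = ItGap).

Lemma in_win_delta t : In t win_delta <->
  (exists t0, In t0 (tdelta M) /\ t = win_step t0) \/
  (exists t0, In t0 (tdelta M) /\ tsrc t0 = tinit M /\ t = win_start t0) \/
  (exists t0, In t0 (tdelta M) /\ tfinal M (tdst t0) /\ t = win_last t0) \/
  (exists t0, In t0 (tdelta M) /\ (tsrc t0 = tinit M /\ tfinal M (tdst t0) /\ in_interval I 0%Q) /\ t = win_single t0).
Proof. unfold win_delta. rewrite !in_app_iff, !in_flat_map, !in_map_iff. split.
  - intros [[t0 [E H]]|[[t0 [H E]]|[[t0 [H E]]|[t0 [H E]]]]].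
    + left; exists t0; auto.
    + apply in_list_if in E. right; left; exists t0; destruct E; subst; auto.
    + apply in_list_if in E. right; right; left; exists t0; destruct E; subst; auto.
    + apply in_list_if in E. right; right; right; exists t0; destruct E; subst; auto.
  - intros [[t0 [H E]]|[[t0 [H [E1 E]]]|[[t0 [H [E1 E]]]|[t0 [H [E1 E]]]]]].
    + left; exists t0; auto.
    + right; left; exists t0; split; auto. apply in_list_if; auto.
    + right; right; left; exists t0; split; auto. apply in_list_if; auto.
    + right; right; right; exists t0; split; auto. apply in_list_if; auto. Qed.

Lemma winA_fresh_start : fresh_start M -> fresh_start winA.
Proof. intros H1 t Ht Hs. simpl in *. apply in_win_delta in Ht.
  destruct Ht as [[t0 [G ->]]|[[t0 [G [E ->]]]|[[t0 [G [E ->]]]|[t0 [G [[E _] ->]]]]]]; simpl in *; try discriminate.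
  - split; auto. rewrite cclocks_cmap, (proj2 (H1 t0 G E)); auto.
  - split; auto. rewrite cclocks_cmap, (proj2 (H1 t0 G E)); auto. Qed.

Lemma winA_ok Pset : tcea_ok Pset M -> tcea_ok Pset winA.
Proof. intros H1 t Ht. simpl in Ht. apply in_win_delta in Ht.
  destruct Ht as [[t0 [G ->]]|[[t0 [G [E ->]]]|[[t0 [G [E ->]]]|[t0 [G [E ->]]]]]]; simpl;
  destruct (H1 t0 G); split; auto; try apply cconsts_cmap; auto.
  split. apply cconsts_cmap; auto. apply interval_guard_consts. Qed.

Lemma win_delta_src t : In t win_delta -> tsrc t <> ItGap.
Proof. intros Ht. apply in_win_delta in Ht.
  destruct Ht as [[t0 [G ->]]|[[t0 [G [E ->]]]|[[t0 [G [E ->]]]|[t0 [G [E ->]]]]]]; simpl; discriminate. Qed.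
Lemma winD_dst t : In t win_delta -> tdst t <> ItInit.
Proof. intros Ht. apply in_win_delta in Ht.
  destruct Ht as [[t0 [G ->]]|[[t0 [G [E ->]]]|[[t0 [G [E ->]]]|[t0 [G [E ->]]]]]]; simpl; discriminate. Qed.

Lemma winA_spec s C : valid_stream s -> fresh_start M ->
  semT winA s C <-> semT M s C /\ in_interval I (ts s (ce C) - ts s (cs C))%Q.
Proof. intros Hv If. rewrite !semT_iff. split.
  - intros [W [p' [nu' [tr' [H1 [H2 [H3 [H4 H5]]]]]]]].
    destruct W as [W1 [W2 [W3 W4]]]. simpl in H1, H4.
    set (i := cs C) in *. set (j := ce C) in *.
    assert (HE : forall k, i < k <= j -> exists a, p' k = ItIn a).
    { intros k Hk. destruct k. lia. destruct (H3 k ltac:(lia)) as [K1 [_ [K3 _]]]. destruct (H3 (S k) ltac:(lia)) as [L1 [L2 _]].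
      destruct (p' (S k)) as [| |a] eqn:E.
      - exfalso; apply (winD_dst _ K1); exact K3.
      - exfalso; apply (win_delta_src _ L1); exact L2.
      - exists a; auto. }
    assert (HK : forall k, i <= k <= j -> exists t0, In t0 (tdelta M) /\
       ((k = i /\ k < j /\ tr' k = win_start t0 /\ tsrc t0 = tinit M) \/
        (k = i /\ k = j /\ tr' k = win_single t0 /\ (tsrc t0 = tinit M /\ tfinal M (tdst t0) /\ in_interval I 0%Q)) \/
        (i < k /\ k < j /\ tr' k = win_step t0) \/
        (i < k /\ k = j /\ tr' k = win_last t0 /\ tfinal M (tdst t0)))).
    { intros k Hk. destruct (H3 k Hk) as [K1 [K2 [K3 _]]].
      assert (Sk : k = i -> tsrc (tr' k) = ItInit) by (intros ->; congruence).
      assert (Sk' : i < k -> exists a, tsrc (tr' k) = ItIn a) by (intros; rewrite K2; apply HE; lia).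
      assert (Dk : k = j -> tdst (tr' k) = ItGap) by (intros ->; congruence).
      assert (Dk' : k < j -> exists a, tdst (tr' k) = ItIn a) by (intros; rewrite K3; apply HE; lia).
      apply in_win_delta in K1.
      destruct K1 as [[t0 [G E]]|[[t0 [G [E1 E]]]|[[t0 [G [E1 E]]]|[t0 [G [E1 E]]]]]]; exists t0; split; auto;
        rewrite E in Sk, Sk', Dk, Dk'; simpl in *.
      - right; right; left. assert (i < k). { destruct (Nat.eq_dec k i); [specialize (Sk e); discriminate|lia]. }
        assert (k < j). { destruct (Nat.eq_dec k j); [specialize (Dk e); discriminate|lia]. } auto.
      - left. assert (k = i). { destruct (Nat.eq_dec k i); auto. destruct (Sk' ltac:(lia)); discriminate. }
        assert (k < j). { destruct (Nat.eq_dec k j); [specialize (Dk e); discriminate|lia]. } auto.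
      - right; right; right. assert (i < k). { destruct (Nat.eq_dec k i); [specialize (Sk e); discriminate|lia]. }
        assert (k = j). { destruct (Nat.eq_dec k j); auto. destruct (Dk' ltac:(lia)); discriminate. } auto.
      - right; left. assert (k = i). { destruct (Nat.eq_dec k i); auto. destruct (Sk' ltac:(lia)); discriminate. }
        assert (k = j). { destruct (Nat.eq_dec k j); auto. destruct (Dk' ltac:(lia)); discriminate. } auto. }
    destruct (@run_segment_pull T A D X _ _ _ _ s (tdelta M) (tinit M) (idle_trans M) ItIn Some (fun _ t0 => tfinal M (tdst t0))
       win_delta i j p' nu' tr' If ltac:(intros q1 q2 Eq; inversion Eq; auto) W2 H3) as [p [nu [tr [P1 [P2 [P3 [P4 P5]]]]]]].
    { intros k Hk. destruct (HK k Hk) as [t0 [G HH]]. exists t0. split; auto.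
      destruct HH as [[Ek [Hl [E Hs]]]|[[Ek [Ek' [E Hs]]]|[[Hl [Hr E]]|[Hl [Ek [E Hf]]]]]]; rewrite E; unfold simulates; simpl;
        refine (conj (fun e He => He) (conj (fun x => iff_refl _) (conj _ (conj _ (conj _ (conj _ (conj _ _))))))).
      - intros nu0 Hc; apply csat_cmap; exact Hc.
      - intros z; split; [intros _; apply (If t0 G Hs)|intros _; exact Logic.I].
      - intros _; exact Hs.
      - intros; lia.
      - intros _; reflexivity.
      - intros; lia.
      - intros nu0 Hc; apply csat_cmap; exact Hc.
      - intros z; split; [intros _; apply (If t0 G (proj1 Hs))|intros _; exact Logic.I].
      - intros _; apply Hs.
      - intros; lia.
      - intros; lia.
      - intros _; apply Hs.
      - intros nu0 Hc; apply csat_cmap; exact Hc.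
      - intros z; apply iff_refl.
      - intros; lia.
      - intros _; reflexivity.
      - intros _; reflexivity.
      - intros; lia.
      - intros nu0 Hc; apply csat_and in Hc; apply csat_cmap; apply Hc.
      - intros z; apply iff_refl.
      - intros; lia.
      - intros _; reflexivity.
      - intros; lia.
      - intros _; exact Hf. }
    split.
    + split. split; auto. exists p, nu, tr. split; auto. split; auto. split; auto. split.
      * rewrite P4. apply (P5 j ltac:(lia)); auto.
      * intros x k. rewrite H5. destruct (pdec (i <= k <= j)) as [Hk|Hk]; [|tauto].
        destruct (P5 k Hk) as [_ [_ [Q _]]]. rewrite Q. tauto.
    + destruct (HK j ltac:(lia)) as [t0 [G HH]].
      destruct HH as [[_ [Hl _]]|[[Ei [_ [E [_ [_ H0]]]]]|[[_ [Hl _]]|[Hl [_ [E Hf]]]]]]; try lia.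
      * eapply in_interval_Qeq; [|exact H0]. rewrite Ei. ring.
      * destruct (H3 j ltac:(lia)) as [_ [_ [_ [Ev [Hg _]]]]]. rewrite E in Hg. simpl in Hg.
        apply csat_and in Hg. destruct Hg as [_ Hg].
        assert (Hc : vshift (nu' j) (dt s j) None = Some (Q2R (ts s j - ts s i))).
        { apply (@clock_since_reset_shifted T A D X _ _ s nu' tr' i j None (run_segment_resets H3)); [| lia |].
          - destruct (HK i ltac:(lia)) as [t1 [_ HH]].
            destruct HH as [[_ [_ [E' _]]]|[[_ [_ [E' _]]]|[[Hx _]|[Hx _]]]]; try lia; rewrite E'; simpl; auto.
          - intros m Hm. destruct (HK m ltac:(lia)) as [t1 [_ HH]].
            destruct HH as [[Hx _]|[[Hx _]|[[_ [_ E']]|[_ [_ [E' _]]]]]]; try lia; rewrite E'; simpl; auto. }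
        apply (csat_interval_guard I None _ Hc); auto.
        apply Qsub_ge0. apply ts_le; auto.
  - intros [[W [p [nu [tr [H1 [H2 [H3 [H4 H5]]]]]]]] Hint].
    split; auto. destruct W as [W1 [W2 [W3 W4]]].
    set (i := cs C) in *. set (j := ce C) in *.
    set (tr' := fun k => if Nat.eqb k i then (if Nat.eqb i j then win_single (tr k) else win_start (tr k))
                         else if Nat.eqb k j then win_last (tr k) else win_step (tr k)).
    set (p' := fun k => if Nat.leb k i then ItInit else if Nat.leb k j then ItIn (p k) else ItGap).
    set (nu' := run_val s (fun _ : option (tclk M) => None) tr' i).
    assert (Hr : follows_resets s nu' tr' i j) by apply run_val_resets.
    exists p', nu', tr'. split. unfold p'; rewrite Nat.leb_refl; reflexivity.
    split. intros z; unfold nu'; rewrite run_val_start; auto.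
    split; [|split].
    + apply (@run_segment_push T A D X _ _ _ _ s (tdelta M) (tinit M) Some _ _ _ p nu tr); auto.
      intros k Hk. destruct (H3 k Hk) as [G1 [G2 [Gd _]]]. unfold tr', p'.
      destruct (Nat.eqb_spec k i) as [Ek|Ek].
      * subst k. rewrite Nat.leb_refl. destruct (Nat.eqb_spec i j) as [Eij|Eij].
        -- destruct (Nat.leb_spec0 (S i) i); [lia|]. destruct (Nat.leb_spec0 (S i) j); [lia|].
           split. apply in_win_delta. right; right; right. exists (tr i). split; auto. split; auto. split. congruence.
           split. rewrite Gd, Eij. exact H4.
           eapply in_interval_Qeq; [|exact Hint]. rewrite Eij; ring.
           simpl. split; auto. split; auto. split; auto. split.
           intros z; split; auto; intros _. apply (If _ G1). congruence.
           intros Hc; apply csat_cmap; auto.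
        -- destruct (Nat.leb_spec0 (S i) i); [lia|]. destruct (Nat.leb_spec0 (S i) j); [|lia].
           split. apply in_win_delta. right; left. exists (tr i). split; auto. split; auto. congruence.
           simpl. split; auto. split. rewrite Gd; auto. split; auto. split.
           intros z; split; auto; intros _. apply (If _ G1). congruence.
           intros Hc; apply csat_cmap; auto.
      * destruct (Nat.leb_spec0 k i); [lia|]. destruct (Nat.leb_spec0 k j); [|lia].
        destruct (Nat.eqb_spec k j) as [Ekj|Ekj].
        -- subst k. destruct (Nat.leb_spec0 (S j) i); [lia|]. destruct (Nat.leb_spec0 (S j) j); [lia|].
           split. apply in_win_delta. right; right; left. exists (tr j). split; auto. split; auto. rewrite Gd; auto.
           simpl. split. rewrite G2; auto. split; auto. split; auto. split.
           intros z; simpl; tauto.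
           intros Hc. apply csat_and. split. apply csat_cmap; auto.
           assert (Hc' : vshift (nu' j) (dt s j) None = Some (Q2R (ts s j - ts s i))).
           { apply (@clock_since_reset_shifted T A D X _ _ s nu' tr' i j None Hr); [| lia |].
             - unfold tr'. rewrite Nat.eqb_refl. destruct (Nat.eqb i j); simpl; auto.
             - intros m Hm. unfold tr'. destruct (Nat.eqb_spec m i); [lia|]. destruct (Nat.eqb m j); simpl; auto. }
           apply (csat_interval_guard I None _ Hc'); auto.
           apply Qsub_ge0. apply ts_le; auto.
        -- destruct (Nat.leb_spec0 (S k) i); [lia|]. destruct (Nat.leb_spec0 (S k) j); [|lia].
           split. apply in_win_delta. left. exists (tr k). split; auto.
           simpl. split. rewrite G2; auto. split. rewrite Gd; auto. split; auto. split.
           intros z; simpl; tauto. intros Hc; apply csat_cmap; auto.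
    + unfold p'. destruct (Nat.leb_spec0 (S j) i); [lia|]. destruct (Nat.leb_spec0 (S j) j); [lia|]. reflexivity.
    + intros x k. rewrite H5. unfold tr'.
      destruct (Nat.eqb k i); [destruct (Nat.eqb i j)|destruct (Nat.eqb k j)]; simpl; tauto.
Qed.

End Part7.


Lemma least_witness (P : nat -> Prop) : (exists n, P n) -> exists n, P n /\ forall m, m < n -> ~ P m.
Proof. intros [n Hn]. induction n as [n IH] using (well_founded_induction Wf_nat.lt_wf).
  destruct (classic (exists m, m < n /\ P m)) as [[m [Hm Pm]]|Hno].
  - apply (IH m Hm Pm).
  - exists n. split; auto. intros m Hm Pm. apply Hno; eauto. Qed.

Lemma run_segment_app {T A D X St Z : Type} s (Dl : list (trans T A D X St Z)) a m b p nu tr :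
  run_segment s Dl a m p nu tr -> run_segment s Dl (S m) b p nu tr -> run_segment s Dl a b p nu tr.
Proof. intros H1 H2 k Hk. destruct (Nat.le_gt_cases k m). apply H1; lia. apply H2; lia. Qed.

Inductive seq_state (S1 S2 : Type) : Type := SqInit | SqGap | SqLeft (a : S1) | SqRight (b : S2).
Arguments SqInit {S1 S2}. Arguments SqGap {S1 S2}. Arguments SqLeft {S1 S2} a. Arguments SqRight {S1 S2} b.

Lemma fin_seq_state {S1 S2 : Type} : (exists l : list S1, forall q, In q l) -> (exists l : list S2, forall q, In q l) ->
  exists l : list (seq_state S1 S2), forall q, In q l.
Proof. intros [l1 H1] [l2 H2]. exists (SqInit :: SqGap :: map SqLeft l1 ++ map SqRight l2). intros [| |a|b]; simpl; auto;
  right; right; apply in_app_iff; [left|right]; apply in_map; auto. Qed.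

Definition seq_sem {T A D X : Type} (s : tstream T A D) (adj : bool) (I : interval) (S1 S2 : CE X -> Prop) (C : CE X) :=
  wfCE s C /\ exists C1 C2, S1 C1 /\ S2 C2 /\ (if adj then ce C1 + 1 = cs C2 else ce C1 < cs C2) /\
    in_interval I (ts s (cs C2) - ts s (ce C1))%Q /\ is_union C C1 C2.

Section Part8.
Variables T A D X : Type.
Notation TA := (TCEA T A D X).
Variables (Mf Mg : TA) (adj : bool) (I : interval).
Notation Zs := (option (tclk Mf + tclk Mg)).
Notation Ss := (seq_state (tst Mf) (tst Mg)).
Notation TrF := (trans T A D X (tst Mf) (tclk Mf)).
Notation TrG := (trans T A D X (tst Mg) (tclk Mg)).
Notation TrS := (trans T A D X Ss Zs).

Definition clkL (z : tclk Mf) : Zs := Some (inl z).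
Definition clkR (z : tclk Mg) : Zs := Some (inr z).
Definition resetL (r : tclk Mf -> Prop) : Zs -> Prop := fun z => match z with Some (inl a) => r a | _ => False end.
Definition resetR (r : tclk Mg -> Prop) : Zs -> Prop := fun z => match z with Some (inr a) => r a | _ => False end.

Definition seq_left (t : TrF) : TrS := embed_trans SqLeft clkL resetL t.
Definition seq_left_start (t : TrF) : TrS := start_trans SqInit SqLeft clkL t.
Definition seq_left_last (t : TrF) : TrS :=
  mkTrans (SqLeft (tsrc t)) (tpred t) (cmap clkL (tguard t)) (tlab t) (fun z => resetL (treset t) z \/ z = None) SqGap.
Definition seq_left_single (t : TrF) : TrS := mkTrans SqInit (tpred t) (cmap clkL (tguard t)) (tlab t) (fun _ => True) SqGap.
Definition seq_right (t : TrG) : TrS := embed_trans SqRight clkR resetR t.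
Definition seq_right_start (t : TrG) : TrS :=
  mkTrans SqGap (tpred t) (CAnd (cmap clkR (tguard t)) (interval_guard I None)) (tlab t) (fun _ => True) (SqRight (tdst t)).
Definition seq_wait : TrS := mkTrans SqGap (fun _ => True) (CTrue _) (fun _ => False) (fun _ => False) SqGap.

Definition seq_delta : list TrS :=
  map seq_left (tdelta Mf) ++ flat_map (fun t => list_if (tsrc t = tinit Mf) (seq_left_start t)) (tdelta Mf) ++
  flat_map (fun t => list_if (tfinal Mf (tdst t)) (seq_left_last t)) (tdelta Mf) ++
  flat_map (fun t => list_if (tsrc t = tinit Mf /\ tfinal Mf (tdst t)) (seq_left_single t)) (tdelta Mf) ++
  map seq_right (tdelta Mg) ++ flat_map (fun t => list_if (tsrc t = tinit Mg) (seq_right_start t)) (tdelta Mg) ++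
  (if adj then [] else [seq_wait]).

Definition seq_final (q : Ss) : Prop := match q with SqRight b => tfinal Mg b | _ => False end.

Definition seqA : TA :=
  @mkTCEA T A D X Ss Zs (fin_seq_state (tst_fin Mf) (tst_fin Mg)) (fin_option (fin_sum (tclk_fin Mf) (tclk_fin Mg)))
    seq_delta SqInit seq_final.

Lemma in_seq_delta t : In t seq_delta <->
  (exists t0, In t0 (tdelta Mf) /\ t = seq_left t0) \/
  (exists t0, In t0 (tdelta Mf) /\ tsrc t0 = tinit Mf /\ t = seq_left_start t0) \/
  (exists t0, In t0 (tdelta Mf) /\ tfinal Mf (tdst t0) /\ t = seq_left_last t0) \/
  (exists t0, In t0 (tdelta Mf) /\ (tsrc t0 = tinit Mf /\ tfinal Mf (tdst t0)) /\ t = seq_left_single t0) \/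
  (exists t0, In t0 (tdelta Mg) /\ t = seq_right t0) \/
  (exists t0, In t0 (tdelta Mg) /\ tsrc t0 = tinit Mg /\ t = seq_right_start t0) \/
  (adj = false /\ t = seq_wait).
Proof. unfold seq_delta. rewrite !in_app_iff, !in_flat_map, !in_map_iff. split.
  - intros [[t0 [E H]]|[[t0 [H E]]|[[t0 [H E]]|[[t0 [H E]]|[[t0 [E H]]|[[t0 [H E]]|H]]]]]].
    + left; exists t0; auto.
    + apply in_list_if in E. right; left; exists t0; destruct E; subst; auto.
    + apply in_list_if in E. right; right; left; exists t0; destruct E; subst; auto.
    + apply in_list_if in E. right; right; right; left; exists t0; destruct E; subst; auto.
    + right; right; right; right; left; exists t0; auto.
    + apply in_list_if in E. right; right; right; right; right; left; exists t0; destruct E; subst; auto.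
    + right; right; right; right; right; right. destruct adj; simpl in H; [contradiction|].
      destruct H as [H|[]]; auto.
  - intros [[t0 [H E]]|[[t0 [H [E1 E]]]|[[t0 [H [E1 E]]]|[[t0 [H [E1 E]]]|[[t0 [H E]]|[[t0 [H [E1 E]]]|[E1 E]]]]]]].
    + left; exists t0; auto.
    + right; left; exists t0; split; auto. apply in_list_if; auto.
    + right; right; left; exists t0; split; auto. apply in_list_if; auto.
    + right; right; right; left; exists t0; split; auto. apply in_list_if; auto.
    + right; right; right; right; left; exists t0; auto.
    + right; right; right; right; right; left; exists t0; split; auto. apply in_list_if; auto.
    + right; right; right; right; right; right. rewrite E1; simpl; auto. Qed.

Lemma seqA_fresh_start : fresh_start Mf -> fresh_start seqA.
Proof. intros H1 t Ht Hs. simpl in *. apply in_seq_delta in Ht.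
  destruct Ht as [[t0 [G ->]]|[[t0 [G [E ->]]]|[[t0 [G [E ->]]]|[[t0 [G [[E _] ->]]]|[[t0 [G ->]]|[[t0 [G [E ->]]]|[_ ->]]]]]]];
    simpl in *; try discriminate.
  - split; auto. rewrite cclocks_cmap, (proj2 (H1 t0 G E)); auto.
  - split; auto. rewrite cclocks_cmap, (proj2 (H1 t0 G E)); auto. Qed.

Lemma seqA_ok Pset : Pset (fun _ => True) -> tcea_ok Pset Mf -> tcea_ok Pset Mg -> tcea_ok Pset seqA.
Proof. intros HT H1 H2 t Ht. simpl in Ht. apply in_seq_delta in Ht.
  destruct Ht as [[t0 [G ->]]|[[t0 [G [E ->]]]|[[t0 [G [E ->]]]|[[t0 [G [E ->]]]|[[t0 [G ->]]|[[t0 [G [E ->]]]|[_ ->]]]]]]];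
    simpl; try (destruct (H1 t0 G)); try (destruct (H2 t0 G)); split; auto; try apply cconsts_cmap; auto.
  split. apply cconsts_cmap; auto. apply interval_guard_consts. Qed.

End Part8.


Section Part9.
Variables T A D X : Type.
Notation TA := (TCEA T A D X).
Variables (Mf Mg : TA) (adj : bool) (I : interval).
Notation Zs := (option (tclk Mf + tclk Mg)).
Notation Ss := (seq_state (tst Mf) (tst Mg)).
Notation TrF := (trans T A D X (tst Mf) (tclk Mf)).
Notation TrG := (trans T A D X (tst Mg) (tclk Mg)).
Notation TrS := (trans T A D X Ss Zs).
Notation sD := (seq_delta Mf Mg adj I).

Lemma seq_delta_from_init t : In t sD -> tsrc t = SqInit ->
  (exists t0, In t0 (tdelta Mf) /\ tsrc t0 = tinit Mf /\ t = seq_left_start Mf Mg t0) \/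
  (exists t0, In t0 (tdelta Mf) /\ (tsrc t0 = tinit Mf /\ tfinal Mf (tdst t0)) /\ t = seq_left_single Mf Mg t0).
Proof. intros Ht Hs. apply in_seq_delta in Ht.
  destruct Ht as [[t0 [G ->]]|[[t0 [G [E ->]]]|[[t0 [G [E ->]]]|[[t0 [G [E ->]]]|[[t0 [G ->]]|[[t0 [G [E ->]]]|[_ ->]]]]]]];
    simpl in Hs; try discriminate; [left|right]; exists t0; auto. Qed.

Lemma seq_delta_from_left t a : In t sD -> tsrc t = SqLeft a ->
  (exists t0, In t0 (tdelta Mf) /\ t = seq_left Mf Mg t0) \/
  (exists t0, In t0 (tdelta Mf) /\ tfinal Mf (tdst t0) /\ t = seq_left_last Mf Mg t0).
Proof. intros Ht Hs. apply in_seq_delta in Ht.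
  destruct Ht as [[t0 [G ->]]|[[t0 [G [E ->]]]|[[t0 [G [E ->]]]|[[t0 [G [E ->]]]|[[t0 [G ->]]|[[t0 [G [E ->]]]|[_ ->]]]]]]];
    simpl in Hs; try discriminate; [left|right]; exists t0; auto. Qed.

Lemma seq_delta_from_gap t : In t sD -> tsrc t = SqGap ->
  (exists t0, In t0 (tdelta Mg) /\ tsrc t0 = tinit Mg /\ t = seq_right_start Mf Mg I t0) \/ (adj = false /\ t = seq_wait Mf Mg).
Proof. intros Ht Hs. apply in_seq_delta in Ht.
  destruct Ht as [[t0 [G ->]]|[[t0 [G [E ->]]]|[[t0 [G [E ->]]]|[[t0 [G [E ->]]]|[[t0 [G ->]]|[[t0 [G [E ->]]]|[E' ->]]]]]]];
    simpl in Hs; try discriminate; [left|right]; [exists t0|]; auto. Qed.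

Lemma seq_delta_from_right t b : In t sD -> tsrc t = SqRight b -> exists t0, In t0 (tdelta Mg) /\ t = seq_right Mf Mg t0.
Proof. intros Ht Hs. apply in_seq_delta in Ht.
  destruct Ht as [[t0 [G ->]]|[[t0 [G [E ->]]]|[[t0 [G [E ->]]]|[[t0 [G [E ->]]]|[[t0 [G ->]]|[[t0 [G [E ->]]]|[_ ->]]]]]]];
    simpl in Hs; try discriminate; exists t0; auto. Qed.


Lemma seqA_fwd s C : valid_stream s -> fresh_start Mf -> fresh_start Mg ->
  semT (seqA Mf Mg adj I) s C -> seq_sem s adj I (semT Mf s) (semT Mg s) C.
Proof. intros Hv If Ig HC. apply semT_iff in HC.
  destruct HC as [W [p' [nu' [tr' [H1 [H2 [H3 [H4 H5]]]]]]]].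
  pose proof W as W0. destruct W as [W1 [W2 [W3 W4]]]. simpl in H1, H4.
  split; auto.
  set (i := cs C) in *. set (j := ce C) in *.
 
  assert (Hex : exists m, i <= m <= j /\ p' (S m) = SqGap).
  { apply NNPP. intros NA.
    assert (HLa : forall k, i < k <= S j -> exists a, p' k = SqLeft a).
    { intros k Hk. induction k. lia. destruct (H3 k ltac:(lia)) as [K1 [K2 [K3 _]]].
      destruct (Nat.eq_dec k i) as [->|Ne].
      - rewrite H1 in K2. destruct (seq_delta_from_init _ K1 K2) as [[t0 [_ [_ E]]]|[t0 [_ [_ E]]]]; rewrite E in K3; simpl in K3.
        + eexists; eauto.
        + exfalso; apply NA; exists i; split; [lia|]. rewrite <- K3; reflexivity.
      - destruct IHk as [a Ha]. lia. rewrite Ha in K2.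
        destruct (seq_delta_from_left _ K1 K2) as [[t0 [_ E]]|[t0 [_ [_ E]]]]; rewrite E in K3; simpl in K3.
        + eexists; eauto.
        + exfalso; apply NA; exists k; split; [lia|]. rewrite <- K3; reflexivity. }
    destruct (HLa (S j) ltac:(lia)) as [a Ha]. rewrite Ha in H4. exact H4. }
  destruct (least_witness _ Hex) as [m [[Hm1 Hm2] Hmin]].
  assert (HL : forall k, i < k <= m -> exists a, p' k = SqLeft a).
  { intros k Hk. induction k. lia. destruct (H3 k ltac:(lia)) as [K1 [K2 [K3 _]]].
    destruct (Nat.eq_dec k i) as [->|Ne].
    - rewrite H1 in K2. destruct (seq_delta_from_init _ K1 K2) as [[t0 [_ [_ E]]]|[t0 [_ [_ E]]]]; rewrite E in K3; simpl in K3.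
      + eexists; eauto.
      + exfalso; apply (Hmin i); [lia|]. split; [lia|]. rewrite <- K3; reflexivity.
    - destruct IHk as [a Ha]. lia. rewrite Ha in K2.
      destruct (seq_delta_from_left _ K1 K2) as [[t0 [_ E]]|[t0 [_ [_ E]]]]; rewrite E in K3; simpl in K3.
      + eexists; eauto.
      + exfalso; apply (Hmin k); [lia|]. split; [lia|]. rewrite <- K3; reflexivity. }
  assert (Hmj : m < j). { destruct (Nat.eq_dec m j); [|lia]. subst m. rewrite Hm2 in H4. destruct H4. }
  assert (Hex2 : exists n, m < n <= j /\ p' (S n) <> SqGap).
  { exists j. split; [lia|]. intros E; rewrite E in H4; exact H4. }
  destruct (least_witness _ Hex2) as [n [[Hn1 Hn2] Hnmin]].
  assert (HG : forall k, m < k <= n -> p' k = SqGap).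
  { intros k Hk. induction k. lia. destruct (Nat.eq_dec k m) as [->|Ne]. exact Hm2.
    apply NNPP. intros Hne. apply (Hnmin k); [lia|]. split; [lia|auto]. }
  assert (Hn : exists t0, In t0 (tdelta Mg) /\ tsrc t0 = tinit Mg /\ tr' n = seq_right_start Mf Mg I t0).
  { destruct (H3 n ltac:(lia)) as [K1 [K2 [K3 _]]]. rewrite (HG n ltac:(lia)) in K2.
    destruct (seq_delta_from_gap _ K1 K2) as [HH|[_ E]]; auto. rewrite E in K3; simpl in K3. exfalso; apply Hn2; rewrite <- K3; reflexivity. }
  destruct Hn as [tn [Gn [Sn En]]].
  assert (HR : forall k, n < k <= S j -> exists b, p' k = SqRight b).
  { intros k Hk. induction k. lia. destruct (H3 k ltac:(lia)) as [K1 [K2 [K3 _]]].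
    destruct (Nat.eq_dec k n) as [->|Ne].
    - rewrite En in K3; simpl in K3. eexists; eauto.
    - destruct IHk as [b Hb]. lia. rewrite Hb in K2.
      destruct (seq_delta_from_right _ K1 K2) as [t0 [_ E]]. rewrite E in K3; simpl in K3. eexists; eauto. }
  assert (HLoop : forall k, m < k < n -> adj = false /\ tr' k = seq_wait Mf Mg).
  { intros k Hk. destruct (H3 k ltac:(lia)) as [K1 [K2 [K3 _]]]. rewrite (HG k ltac:(lia)) in K2.
    rewrite (HG (S k) ltac:(lia)) in K3.
    destruct (seq_delta_from_gap _ K1 K2) as [[t0 [_ [_ E]]]|HH]; auto. rewrite E in K3; simpl in K3; discriminate. }
 
  assert (HKf : forall k, i <= k <= m -> exists t0, In t0 (tdelta Mf) /\
     ((k = i /\ k < m /\ tr' k = seq_left_start Mf Mg t0 /\ tsrc t0 = tinit Mf) \/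
      (k = i /\ k = m /\ tr' k = seq_left_single Mf Mg t0 /\ (tsrc t0 = tinit Mf /\ tfinal Mf (tdst t0))) \/
      (i < k /\ k < m /\ tr' k = seq_left Mf Mg t0) \/
      (i < k /\ k = m /\ tr' k = seq_left_last Mf Mg t0 /\ tfinal Mf (tdst t0)))).
  { intros k Hk. destruct (H3 k ltac:(lia)) as [K1 [K2 [K3 _]]].
    destruct (Nat.eq_dec k i) as [->|Ne].
    - rewrite H1 in K2. destruct (seq_delta_from_init _ K1 K2) as [[t0 [G [Es E]]]|[t0 [G [Es E]]]]; exists t0; split; auto;
        rewrite E in K3; simpl in K3.
      + left. destruct (Nat.eq_dec i m) as [Eq|Nq]; [|split; [auto|split; [lia|auto]]].
        rewrite Eq in K3. rewrite Hm2 in K3. discriminate.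
      + right; left. destruct (Nat.eq_dec i m) as [Eq|Nq]; [split; auto|].
        destruct (HL (S i) ltac:(lia)) as [a Ha]. rewrite Ha in K3; discriminate.
    - destruct (HL k ltac:(lia)) as [a Ha]. rewrite Ha in K2.
      destruct (seq_delta_from_left _ K1 K2) as [[t0 [G E]]|[t0 [G [Ef E]]]]; exists t0; split; auto; rewrite E in K3; simpl in K3.
      + right; right; left. destruct (Nat.eq_dec k m) as [Eq|Nq]; [|split; [lia|split; [lia|auto]]].
        rewrite Eq in K3. rewrite Hm2 in K3. discriminate.
      + right; right; right. destruct (Nat.eq_dec k m) as [Eq|Nq]; [split; [lia|auto]|].
        destruct (HL (S k) ltac:(lia)) as [a' Ha']. rewrite Ha' in K3; discriminate. }
  destruct (@run_segment_pull T A D X _ _ _ _ s (tdelta Mf) (tinit Mf) (idle_trans Mf) SqLeft (clkL Mf Mg) (fun _ t0 => tfinal Mf (tdst t0))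
       sD i m p' nu' tr' If ltac:(intros q1 q2 Eq; inversion Eq; auto) (proj1 Hm1)
       ltac:(intros k Hk; apply H3; lia)) as [p1 [nu1 [tr1 [P1 [P2 [P3 [P4 P5]]]]]]].
  { intros k Hk. destruct (HKf k Hk) as [t0 [G HH]]. exists t0. split; auto.
    destruct HH as [[Ek [Hl [E Hs]]]|[[Ek [Ek' [E Hs]]]|[[Hl [Hr E]]|[Hl [Ek [E Hf]]]]]]; rewrite E; unfold simulates; simpl;
      refine (conj (fun e He => He) (conj (fun x => iff_refl _) (conj _ (conj _ (conj _ (conj _ (conj _ _))))))).
    - intros nu0 Hc; apply csat_cmap; exact Hc.
    - intros z; split; [intros _; apply (If t0 G Hs)|intros _; exact Logic.I].
    - intros _; exact Hs.
    - intros; lia.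
    - intros _; reflexivity.
    - intros; lia.
    - intros nu0 Hc; apply csat_cmap; exact Hc.
    - intros z; split; [intros _; apply (If t0 G (proj1 Hs))|intros _; exact Logic.I].
    - intros _; apply Hs.
    - intros; lia.
    - intros; lia.
    - intros _; apply Hs.
    - intros nu0 Hc; apply csat_cmap; exact Hc.
    - intros z; apply iff_refl.
    - intros; lia.
    - intros _; reflexivity.
    - intros _; reflexivity.
    - intros; lia.
    - intros nu0 Hc; apply csat_cmap; exact Hc.
    - intros z; simpl; split; [intros [H|H]; [exact H|discriminate]|intros H; left; exact H].
    - intros; lia.
    - intros _; reflexivity.
    - intros; lia.
    - intros _; exact Hf. }
 
  assert (HKg : forall k, n <= k <= j -> exists t0, In t0 (tdelta Mg) /\
     ((k = n /\ tr' k = seq_right_start Mf Mg I t0 /\ tsrc t0 = tinit Mg) \/ (n < k /\ tr' k = seq_right Mf Mg t0))).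
  { intros k Hk. destruct (Nat.eq_dec k n) as [->|Ne]. exists tn; auto.
    destruct (H3 k ltac:(lia)) as [K1 [K2 _]]. destruct (HR k ltac:(lia)) as [b Hb]. rewrite Hb in K2.
    destruct (seq_delta_from_right _ K1 K2) as [t0 [G E]]. exists t0; split; auto. right; split; auto; lia. }
  destruct (@run_segment_pull T A D X _ _ _ _ s (tdelta Mg) (tinit Mg) (idle_trans Mg) SqRight (clkR Mf Mg) (fun t' t0 => tdst t' = SqRight (tdst t0))
       sD n j p' nu' tr' Ig ltac:(intros q1 q2 Eq; inversion Eq; auto) (proj2 Hn1)
       ltac:(intros k Hk; apply H3; lia)) as [p2 [nu2 [tr2 [Q1 [Q2 [Q3 [Q4 Q5]]]]]]].
  { intros k Hk. destruct (HKg k Hk) as [t0 [G HH]]. exists t0. split; auto.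
    destruct HH as [[Ek [E Hs]]|[Hl E]]; rewrite E; unfold simulates; simpl;
      refine (conj (fun e He => He) (conj (fun x => iff_refl _) (conj _ (conj _ (conj _ (conj _ (conj _ _))))))).
    - intros nu0 Hc; apply csat_and in Hc; apply csat_cmap; apply Hc.
    - intros z; split; [intros _; apply (Ig t0 G Hs)|intros _; exact Logic.I].
    - intros _; exact Hs.
    - intros; lia.
    - intros _; reflexivity.
    - intros _; reflexivity.
    - intros nu0 Hc; apply csat_cmap; exact Hc.
    - intros z; apply iff_refl.
    - intros; lia.
    - intros _; reflexivity.
    - intros _; reflexivity.
    - intros _; reflexivity. }
  exists (mkCE i m (fun x k => i <= k <= m /\ tlab (tr' k) x)), (mkCE n j (fun x k => n <= k <= j /\ tlab (tr' k) x)).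
  simpl. split; [|split; [|split; [|split]]].
  - apply semT_iff. split. split; simpl; [lia|split; [lia|split; [lia|]]]. intros x k [Hk _]; exact Hk.
    exists p1, nu1, tr1. simpl. split; auto. split; auto. split; auto. split.
    + rewrite P4. apply (P5 m ltac:(lia)); auto.
    + intros x k. destruct (pdec (i <= k <= m)) as [Hk|Hk]; [|tauto].
      destruct (P5 k Hk) as [_ [_ [Q _]]]. rewrite Q. tauto.
  - apply semT_iff. split. split; simpl; [lia|split; [lia|split; [lia|]]]. intros x k [Hk _]; exact Hk.
    exists p2, nu2, tr2. simpl. split; auto. split; auto. split; auto. split.
    + rewrite Q4. destruct (Q5 j ltac:(lia)) as [_ [_ [_ [_ [_ [_ [_ Q]]]]]]].
      destruct (H3 j ltac:(lia)) as [_ [_ [K3 _]]].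
      assert (Q' : p' (S j) = SqRight (tdst (tr2 j))) by (rewrite <- K3; exact (proj2 Q eq_refl)).
      rewrite Q' in H4. exact H4.
    + intros x k. destruct (pdec (n <= k <= j)) as [Hk|Hk]; [|tauto].
      destruct (Q5 k Hk) as [_ [_ [Q _]]]. rewrite Q. tauto.
  - destruct adj eqn:Ea; [|lia]. destruct (Nat.eq_dec n (S m)); [lia|].
    destruct (HLoop (S m) ltac:(lia)); discriminate.
  - assert (Hc : vshift (nu' n) (dt s n) None = Some (Q2R (ts s n - ts s m))).
    { apply (@clock_since_reset_shifted T A D X _ _ s nu' tr' m j None); [| |lia|].
      - eapply follows_resets_sub; [eapply run_segment_resets; exact H3| lia | lia].
      - destruct (HKf m ltac:(lia)) as [t1 [_ HH]].
        destruct HH as [[_ [Hx _]]|[[_ [_ [E' _]]]|[[_ [Hx _]]|[_ [_ [E' _]]]]]]; try lia; rewrite E'; simpl; auto.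
      - intros k Hk. destruct (HLoop k Hk) as [_ E']. rewrite E'; simpl; auto. }
    destruct (H3 n ltac:(lia)) as [_ [_ [_ [_ [Hg _]]]]]. rewrite En in Hg. simpl in Hg.
    apply csat_and in Hg. destruct Hg as [_ Hg].
    apply (csat_interval_guard I None _ Hc); auto. apply Qsub_ge0. apply ts_le; auto; lia.
  - split; [simpl; lia|split; [simpl; lia|]]. intros x k. rewrite H5. simpl.
    destruct (Nat.le_gt_cases k m).
    { split; [intros [Hk Hl]; left; split; [lia|auto] | intros [[Hk Hl]|[Hk Hl]]; split; auto; lia]. }
    destruct (Nat.le_gt_cases n k).
    { split; [intros [Hk Hl]; right; split; [lia|auto] | intros [[Hk Hl]|[Hk Hl]]; split; auto; lia]. }
    split; [|intros [[Hk Hl]|[Hk Hl]]; lia]. intros [Hk Hl]. destruct (HLoop k ltac:(lia)) as [_ E]. rewrite E in Hl. destruct Hl.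
Qed.

End Part9.


Lemma ev_sat_True {T A D : Type} (s : tstream T A D) k : 1 <= k <= length s -> ev_sat s k (fun _ => True).
Proof. intros Hk. destruct (nth_error s (k - 1)) as [[e t]|] eqn:E.
  - exists e, t. split; [lia|]. auto.
  - apply nth_error_None in E. lia. Qed.

Lemma run_segment_empty {T A D X St Z : Type} s (Dl : list (trans T A D X St Z)) a b p nu tr :
  b < a -> run_segment s Dl a b p nu tr.
Proof. intros H k Hk. lia. Qed.

Section Part10.
Variables T A D X : Type.
Notation TA := (TCEA T A D X).
Variables (Mf Mg : TA) (adj : bool) (I : interval).
Notation Zs := (option (tclk Mf + tclk Mg)).
Notation Ss := (seq_state (tst Mf) (tst Mg)).
Notation TrF := (trans T A D X (tst Mf) (tclk Mf)).
Notation TrG := (trans T A D X (tst Mg) (tclk Mg)).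
Notation TrS := (trans T A D X Ss Zs).
Notation sD := (seq_delta Mf Mg adj I).

Lemma seqA_bwd s C : valid_stream s -> fresh_start Mf -> fresh_start Mg ->
  seq_sem s adj I (semT Mf s) (semT Mg s) C -> semT (seqA Mf Mg adj I) s C.
Proof. intros Hv If Ig [W [C1 [C2 [HC1 [HC2 [Hgap [Hint [U1 [U2 U3]]]]]]]]].
  apply semT_iff in HC1. destruct HC1 as [W1 [p1 [nu1 [tr1 [H1 [H2 [H3 [H4 H5]]]]]]]].
  apply semT_iff in HC2. destruct HC2 as [W2 [p2 [nu2 [tr2 [K1 [K2 [K3 [K4 K5]]]]]]]].
  destruct W1 as [A1 [A2 [A3 A4]]]. destruct W2 as [B1 [B2 [B3 B4]]].
  set (i1 := cs C1) in *. set (j1 := ce C1) in *. set (i2 := cs C2) in *. set (j2 := ce C2) in *.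
  assert (Hg : j1 < i2) by (destruct adj; lia).
  assert (Ecs : cs C = i1) by (rewrite U1; lia). assert (Ece : ce C = j2) by (rewrite U2; lia).
  apply semT_iff. split; auto. rewrite Ecs, Ece.
  set (tr' := fun k => if Nat.leb k j1 then
                 (if Nat.eqb k i1 then (if Nat.eqb i1 j1 then seq_left_single Mf Mg (tr1 k) else seq_left_start Mf Mg (tr1 k))
                  else if Nat.eqb k j1 then seq_left_last Mf Mg (tr1 k) else seq_left Mf Mg (tr1 k))
               else if Nat.ltb k i2 then seq_wait Mf Mg
               else if Nat.eqb k i2 then seq_right_start Mf Mg I (tr2 k) else seq_right Mf Mg (tr2 k)).
  set (p' := fun k => if Nat.leb k i1 then SqInit else if Nat.leb k j1 then SqLeft (p1 k)
                      else if Nat.leb k i2 then SqGap else SqRight (p2 k) : Ss).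
  set (nu' := run_val s (fun _ : Zs => None) tr' i1).
  assert (Hr : follows_resets s nu' tr' i1 j2) by apply run_val_resets.
  assert (Ea : i1 = j1 -> tr' i1 = seq_left_single Mf Mg (tr1 i1)).
  { intros E. unfold tr'. destruct (Nat.leb_spec0 i1 j1); [|lia]. rewrite Nat.eqb_refl. rewrite E, Nat.eqb_refl. reflexivity. }
  assert (Eb : i1 < j1 -> tr' i1 = seq_left_start Mf Mg (tr1 i1)).
  { intros E. unfold tr'. destruct (Nat.leb_spec0 i1 j1); [|lia]. rewrite Nat.eqb_refl.
    destruct (Nat.eqb_spec i1 j1); [lia|reflexivity]. }
  assert (Ec : forall k, i1 < k -> k = j1 -> tr' k = seq_left_last Mf Mg (tr1 k)).
  { intros k E1 E2. unfold tr'. destruct (Nat.leb_spec0 k j1); [|lia]. destruct (Nat.eqb_spec k i1); [lia|].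
    destruct (Nat.eqb_spec k j1); [reflexivity|lia]. }
  assert (Ed : forall k, i1 < k < j1 -> tr' k = seq_left Mf Mg (tr1 k)).
  { intros k E1. unfold tr'. destruct (Nat.leb_spec0 k j1); [|lia]. destruct (Nat.eqb_spec k i1); [lia|].
    destruct (Nat.eqb_spec k j1); [lia|reflexivity]. }
  assert (Ee : forall k, j1 < k < i2 -> tr' k = seq_wait Mf Mg).
  { intros k E1. unfold tr'. destruct (Nat.leb_spec0 k j1); [lia|]. destruct (Nat.ltb_spec0 k i2); [reflexivity|lia]. }
  assert (Ef : tr' i2 = seq_right_start Mf Mg I (tr2 i2)).
  { unfold tr'. destruct (Nat.leb_spec0 i2 j1); [lia|]. destruct (Nat.ltb_spec0 i2 i2); [lia|]. rewrite Nat.eqb_refl; reflexivity. }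
  assert (Eg : forall k, i2 < k -> tr' k = seq_right Mf Mg (tr2 k)).
  { intros k E1. unfold tr'. destruct (Nat.leb_spec0 k j1); [lia|]. destruct (Nat.ltb_spec0 k i2); [lia|].
    destruct (Nat.eqb_spec k i2); [lia|reflexivity]. }
  assert (Pa : p' i1 = SqInit). { unfold p'. rewrite Nat.leb_refl. reflexivity. }
  assert (Pb : forall k, i1 < k <= j1 -> p' k = SqLeft (p1 k)).
  { intros k Hk. unfold p'. destruct (Nat.leb_spec0 k i1); [lia|]. destruct (Nat.leb_spec0 k j1); [reflexivity|lia]. }
  assert (Pc : forall k, j1 < k <= i2 -> p' k = SqGap).
  { intros k Hk. unfold p'. destruct (Nat.leb_spec0 k i1); [lia|]. destruct (Nat.leb_spec0 k j1); [lia|].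
    destruct (Nat.leb_spec0 k i2); [reflexivity|lia]. }
  assert (Pd : forall k, i2 < k -> p' k = SqRight (p2 k)).
  { intros k Hk. unfold p'. destruct (Nat.leb_spec0 k i1); [lia|]. destruct (Nat.leb_spec0 k j1); [lia|].
    destruct (Nat.leb_spec0 k i2); [lia|reflexivity]. }
  exists p', nu', tr'. split; auto. split. intros z; unfold nu'; rewrite run_val_start; auto.
  split; [|split].
  - apply run_segment_app with j1.
    + apply (@run_segment_push T A D X _ _ _ _ s (tdelta Mf) (tinit Mf) (clkL Mf Mg) _ _ _ p1 nu1 tr1); auto.
      eapply follows_resets_sub; [exact Hr|lia|lia].
      intros k Hk. destruct (H3 k Hk) as [G1 [G2 [Gd _]]].
      destruct (Nat.eq_dec k i1) as [Ek|Ek]; [destruct (Nat.eq_dec i1 j1) as [Eij|Eij]|destruct (Nat.eq_dec k j1) as [Ekj|Ekj]].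
      * subst k. rewrite (Ea Eij). split. apply in_seq_delta. right; right; right; left. exists (tr1 i1).
        split; auto. split; [split; [congruence|]|reflexivity]. rewrite Gd. rewrite Eij. exact H4.
        simpl. split; [auto|]. split. rewrite Pc by lia. reflexivity. split; auto. split.
        intros z; split; [intros _; apply (If _ G1); congruence|intros _; exact Logic.I].
        intros Hc; apply csat_cmap; auto.
      * subst k. rewrite (Eb ltac:(lia)). split. apply in_seq_delta. right; left. exists (tr1 i1).
        split; auto. split; [congruence|reflexivity].
        simpl. split; [auto|]. split. rewrite Pb by lia. rewrite Gd; reflexivity. split; auto. split.
        intros z; split; [intros _; apply (If _ G1); congruence|intros _; exact Logic.I].
        intros Hc; apply csat_cmap; auto.
      * rewrite (Ec k ltac:(lia) Ekj). split. apply in_seq_delta. right; right; left. exists (tr1 k).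
        split; auto. split; [|reflexivity]. rewrite Gd, Ekj. exact H4.
        simpl. split. rewrite Pb by lia. rewrite G2; reflexivity. split. rewrite Pc by lia. reflexivity. split; auto.
        split. intros z; simpl; split; [intros [HH|HH]; [exact HH|discriminate]|intros HH; left; exact HH].
        intros Hc; apply csat_cmap; auto.
      * rewrite (Ed k ltac:(lia)). split. apply in_seq_delta. left. exists (tr1 k). split; auto.
        simpl. split. rewrite Pb by lia. rewrite G2; reflexivity. split. rewrite Pb by lia. rewrite Gd; reflexivity.
        split; auto. split. intros z; simpl; tauto. intros Hc; apply csat_cmap; auto.
    + apply run_segment_app with (i2 - 1).
      * intros k Hk. rewrite (Ee k ltac:(lia)).
        split. apply in_seq_delta. right; right; right; right; right; right. split; auto. destruct adj; auto; lia.
        simpl. split. rewrite Pc by lia. reflexivity. split. rewrite Pc by lia. reflexivity.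
        split. apply ev_sat_True. lia. split. split; [intros z []|exact Logic.I].
        pose proof (Hr k ltac:(lia)) as HH. rewrite (Ee k ltac:(lia)) in HH. exact HH.
      * replace (S (i2 - 1)) with i2 by lia.
        apply (@run_segment_push T A D X _ _ _ _ s (tdelta Mg) (tinit Mg) (clkR Mf Mg) _ _ _ p2 nu2 tr2); auto.
        eapply follows_resets_sub; [exact Hr|lia|lia].
        intros k Hk. destruct (K3 k Hk) as [G1 [G2 [Gd _]]].
        destruct (Nat.eq_dec k i2) as [Ek|Ek].
        -- subst k. rewrite Ef. split. apply in_seq_delta. right; right; right; right; right; left. exists (tr2 i2).
           split; auto. split; [congruence|reflexivity].
           simpl. split. rewrite Pc by lia. reflexivity. split. rewrite Pd by lia. rewrite Gd; reflexivity. split; auto.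
           split. intros z; split; [intros _; apply (Ig _ G1); congruence|intros _; exact Logic.I].
           intros Hc. apply csat_and. split. apply csat_cmap; auto.
           assert (Hc' : vshift (nu' i2) (dt s i2) None = Some (Q2R (ts s i2 - ts s j1))).
           { apply (@clock_since_reset_shifted T A D X _ _ s nu' tr' j1 j2 None); [| |lia|].
             - eapply follows_resets_sub; [exact Hr|lia|lia].
             - destruct (Nat.eq_dec i1 j1) as [Eij|Eij].
               + rewrite <- Eij, (Ea Eij). simpl; auto.
               + rewrite (Ec j1 ltac:(lia) eq_refl). simpl; auto.
             - intros m Hm. rewrite (Ee m Hm). simpl; auto. }
           apply (csat_interval_guard I None _ Hc'); auto. apply Qsub_ge0. apply ts_le; auto; lia.
        -- rewrite (Eg k ltac:(lia)). split. apply in_seq_delta. right; right; right; right; left. exists (tr2 k). split; auto.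
           simpl. split. rewrite Pd by lia. rewrite G2; reflexivity. split. rewrite Pd by lia. rewrite Gd; reflexivity.
           split; auto. split. intros z; simpl; tauto. intros Hc; apply csat_cmap; auto.
  - rewrite Pd by lia. exact K4.
  - intros x k. rewrite U3, H5, K5.
    destruct (Nat.le_gt_cases k j1).
    + destruct (Nat.eq_dec k i1) as [Ek|Ek]; [destruct (Nat.eq_dec i1 j1) as [Eij|Eij]|destruct (Nat.eq_dec k j1) as [Ekj|Ekj]].
      * subst k. rewrite (Ea Eij). simpl. split; [intros [[Hk Hl]|[Hk Hl]]; [split; [lia|auto]|lia]|intros [Hk Hl]; left; split; [lia|auto]].
      * subst k. rewrite (Eb ltac:(lia)). simpl. split; [intros [[Hk Hl]|[Hk Hl]]; [split; [lia|auto]|lia]|intros [Hk Hl]; left; split; [lia|auto]].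
      * destruct (Nat.le_gt_cases i1 k); [|split; [intros [[Hk Hl]|[Hk Hl]]; lia|intros [Hk Hl]; lia]].
        rewrite (Ec k ltac:(lia) Ekj). simpl. split; [intros [[Hk Hl]|[Hk Hl]]; [split; [lia|auto]|lia]|intros [Hk Hl]; left; split; [lia|auto]].
      * destruct (Nat.le_gt_cases i1 k); [|split; [intros [[Hk Hl]|[Hk Hl]]; lia|intros [Hk Hl]; lia]].
        rewrite (Ed k ltac:(lia)). simpl. split; [intros [[Hk Hl]|[Hk Hl]]; [split; [lia|auto]|lia]|intros [Hk Hl]; left; split; [lia|auto]].
    + destruct (Nat.lt_ge_cases k i2).
      * rewrite (Ee k ltac:(lia)). simpl. split; [intros [[Hk Hl]|[Hk Hl]]; lia|intros [Hk []]].
      * destruct (Nat.eq_dec k i2) as [Ek|Ek].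
        -- subst k. rewrite Ef. simpl. split; [intros [[Hk Hl]|[Hk Hl]]; [lia|split; [lia|auto]]|intros [Hk Hl]; right; split; [lia|auto]].
        -- rewrite (Eg k ltac:(lia)). simpl. split; [intros [[Hk Hl]|[Hk Hl]]; [lia|split; [lia|auto]]|intros [Hk Hl]; right; split; [lia|auto]].
Qed.

End Part10.


Inductive iter_sem {T A D X : Type} (s : tstream T A D) (adj : bool) (I : interval) (S : CE X -> Prop) : CE X -> Prop :=
| it_base C : S C -> iter_sem s adj I S C
| it_step C C1 C2 : wfCE s C -> S C1 -> iter_sem s adj I S C2 ->
    (if adj then ce C1 + 1 = cs C2 else ce C1 < cs C2) ->
    in_interval I (ts s (cs C2) - ts s (ce C1))%Q -> is_union C C1 C2 -> iter_sem s adj I S C.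

Section Part11.
Variables T A D X : Type.
Notation TA := (TCEA T A D X).
Variables (M : TA) (adj : bool) (I : interval).
Notation Zi := (option (tclk M)).
Notation Si := (iter_state (tst M)).
Notation TrM := (trans T A D X (tst M) (tclk M)).
Notation TrI := (trans T A D X Si Zi).

Definition iter_step (t : TrM) : TrI := embed_trans ItIn Some some_reset t.
Definition iter_start (t : TrM) : TrI := start_trans ItInit ItIn Some t.
Definition iter_last (t : TrM) : TrI :=
  mkTrans (ItIn (tsrc t)) (tpred t) (cmap Some (tguard t)) (tlab t) (fun z => some_reset (treset t) z \/ z = None) ItGap.
Definition iter_single (t : TrM) : TrI := mkTrans ItInit (tpred t) (cmap Some (tguard t)) (tlab t) (fun _ => True) ItGap.
Definition restart (t : TrI) : TrI :=
  mkTrans ItGap (tpred t) (CAnd (tguard t) (interval_guard I None)) (tlab t) (treset t) (tdst t).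
Definition iter_wait : TrI := mkTrans ItGap (fun _ => True) (CTrue _) (fun _ => False) (fun _ => False) ItGap.

Definition iter_delta : list TrI :=
  map iter_step (tdelta M) ++ flat_map (fun t => list_if (tsrc t = tinit M) (iter_start t)) (tdelta M) ++
  flat_map (fun t => list_if (tfinal M (tdst t)) (iter_last t)) (tdelta M) ++
  flat_map (fun t => list_if (tsrc t = tinit M /\ tfinal M (tdst t)) (iter_single t)) (tdelta M) ++
  flat_map (fun t => list_if (tsrc t = tinit M) (restart (iter_start t))) (tdelta M) ++
  flat_map (fun t => list_if (tsrc t = tinit M /\ tfinal M (tdst t)) (restart (iter_single t))) (tdelta M) ++
  (if adj then [] else [iter_wait]).

Definition iter_final (q : Si) : Prop := match q with ItIn a => tfinal M a | _ => False end.

Definition iterA : TA :=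
  @mkTCEA T A D X Si Zi (fin_iter_state (tst_fin M)) (fin_option (tclk_fin M)) iter_delta ItInit iter_final.

Lemma in_iter_delta t : In t iter_delta <->
  (exists t0, In t0 (tdelta M) /\ t = iter_step t0) \/
  (exists t0, In t0 (tdelta M) /\ tsrc t0 = tinit M /\ t = iter_start t0) \/
  (exists t0, In t0 (tdelta M) /\ tfinal M (tdst t0) /\ t = iter_last t0) \/
  (exists t0, In t0 (tdelta M) /\ (tsrc t0 = tinit M /\ tfinal M (tdst t0)) /\ t = iter_single t0) \/
  (exists t0, In t0 (tdelta M) /\ tsrc t0 = tinit M /\ t = restart (iter_start t0)) \/
  (exists t0, In t0 (tdelta M) /\ (tsrc t0 = tinit M /\ tfinal M (tdst t0)) /\ t = restart (iter_single t0)) \/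
  (adj = false /\ t = iter_wait).
Proof. unfold iter_delta. rewrite !in_app_iff, !in_flat_map, !in_map_iff. split.
  - intros [[t0 [E H]]|[[t0 [H E]]|[[t0 [H E]]|[[t0 [H E]]|[[t0 [H E]]|[[t0 [H E]]|H]]]]]].
    + left; exists t0; auto.
    + apply in_list_if in E. right; left; exists t0; destruct E; subst; auto.
    + apply in_list_if in E. right; right; left; exists t0; destruct E; subst; auto.
    + apply in_list_if in E. right; right; right; left; exists t0; destruct E; subst; auto.
    + apply in_list_if in E. right; right; right; right; left; exists t0; destruct E; subst; auto.
    + apply in_list_if in E. right; right; right; right; right; left; exists t0; destruct E; subst; auto.
    + right; right; right; right; right; right. destruct adj; simpl in H; [contradiction|].
      destruct H as [H|[]]; auto.
  - intros [[t0 [H E]]|[[t0 [H [E1 E]]]|[[t0 [H [E1 E]]]|[[t0 [H [E1 E]]]|[[t0 [H [E1 E]]]|[[t0 [H [E1 E]]]|[E1 E]]]]]]].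
    + left; exists t0; auto.
    + right; left; exists t0; split; auto. apply in_list_if; auto.
    + right; right; left; exists t0; split; auto. apply in_list_if; auto.
    + right; right; right; left; exists t0; split; auto. apply in_list_if; auto.
    + right; right; right; right; left; exists t0; split; auto. apply in_list_if; auto.
    + right; right; right; right; right; left; exists t0; split; auto. apply in_list_if; auto.
    + right; right; right; right; right; right. rewrite E1; simpl; auto. Qed.

Lemma iterA_fresh_start : fresh_start M -> fresh_start iterA.
Proof. intros H1 t Ht Hs. simpl in *. apply in_iter_delta in Ht.
  destruct Ht as [[t0 [G ->]]|[[t0 [G [E ->]]]|[[t0 [G [E ->]]]|[[t0 [G [[E _] ->]]]|[[t0 [G [E ->]]]|[[t0 [G [[E _] ->]]]|[_ ->]]]]]]];
    simpl in *; try discriminate.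
  - split; auto. rewrite cclocks_cmap, (proj2 (H1 t0 G E)); auto.
  - split; auto. rewrite cclocks_cmap, (proj2 (H1 t0 G E)); auto. Qed.

Lemma iterA_ok Pset : Pset (fun _ => True) -> tcea_ok Pset M -> tcea_ok Pset iterA.
Proof. intros HT H1 t Ht. simpl in Ht. apply in_iter_delta in Ht.
  destruct Ht as [[t0 [G ->]]|[[t0 [G [E ->]]]|[[t0 [G [E ->]]]|[[t0 [G [E ->]]]|[[t0 [G [E ->]]]|[[t0 [G [E ->]]]|[_ ->]]]]]]];
    simpl; try (destruct (H1 t0 G)); split; auto; try apply cconsts_cmap; auto;
    split; try apply cconsts_cmap; auto; apply interval_guard_consts. Qed.

Lemma iter_delta_from_init t : In t iter_delta -> tsrc t = ItInit ->
  (exists t0, In t0 (tdelta M) /\ tsrc t0 = tinit M /\ t = iter_start t0) \/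
  (exists t0, In t0 (tdelta M) /\ (tsrc t0 = tinit M /\ tfinal M (tdst t0)) /\ t = iter_single t0).
Proof. intros Ht Hs. apply in_iter_delta in Ht.
  destruct Ht as [[t0 [G ->]]|[[t0 [G [E ->]]]|[[t0 [G [E ->]]]|[[t0 [G [E ->]]]|[[t0 [G [E ->]]]|[[t0 [G [E ->]]]|[_ ->]]]]]]];
    simpl in Hs; try discriminate; [left|right]; exists t0; auto. Qed.

Lemma iter_delta_from_in t a : In t iter_delta -> tsrc t = ItIn a ->
  (exists t0, In t0 (tdelta M) /\ t = iter_step t0) \/
  (exists t0, In t0 (tdelta M) /\ tfinal M (tdst t0) /\ t = iter_last t0).
Proof. intros Ht Hs. apply in_iter_delta in Ht.
  destruct Ht as [[t0 [G ->]]|[[t0 [G [E ->]]]|[[t0 [G [E ->]]]|[[t0 [G [E ->]]]|[[t0 [G [E ->]]]|[[t0 [G [E ->]]]|[_ ->]]]]]]];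
    simpl in Hs; try discriminate; [left|right]; exists t0; auto. Qed.

Lemma iter_delta_from_gap t : In t iter_delta -> tsrc t = ItGap ->
  (exists t0, In t0 (tdelta M) /\ tsrc t0 = tinit M /\ t = restart (iter_start t0)) \/
  (exists t0, In t0 (tdelta M) /\ (tsrc t0 = tinit M /\ tfinal M (tdst t0)) /\ t = restart (iter_single t0)) \/
  (adj = false /\ t = iter_wait).
Proof. intros Ht Hs. apply in_iter_delta in Ht.
  destruct Ht as [[t0 [G ->]]|[[t0 [G [E ->]]]|[[t0 [G [E ->]]]|[[t0 [G [E ->]]]|[[t0 [G [E ->]]]|[[t0 [G [E ->]]]|[E ->]]]]]]];
    simpl in Hs; try discriminate.
  - left; exists t0; auto.
  - right; left; exists t0; auto.
  - right; right; auto. Qed.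

End Part11.


Section Part12.
Variables T A D X : Type.
Notation TA := (TCEA T A D X).
Variables (M : TA) (adj : bool) (I : interval).
Notation Zi := (option (tclk M)).
Notation Si := (iter_state (tst M)).
Notation TrM := (trans T A D X (tst M) (tclk M)).
Notation TrI := (trans T A D X Si Zi).
Notation iD := (iter_delta M adj I).

Lemma iterA_base s C : fresh_start M -> semT M s C -> semT (iterA M adj I) s C.
Proof. intros If HC. apply semT_iff in HC. destruct HC as [W [p [nu [tr [H1 [H2 [H3 [H4 H5]]]]]]]].
  apply semT_iff. split; auto. assert (Wl : cs C <= ce C) by apply W.
  set (tr' := fun k => if Nat.eqb k (cs C) then iter_start M (tr k) else iter_step M (tr k)).
  set (p' := fun k => if Nat.leb k (cs C) then ItInit else ItIn (p k) : Si).
  set (nu' := run_val s (fun _ : Zi => None) tr' (cs C)).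
  exists p', nu', tr'. split. unfold p'; rewrite Nat.leb_refl; reflexivity.
  split. intros z; unfold nu'; rewrite run_val_start; auto.
  split; [|split].
  - apply (@run_segment_push T A D X _ _ _ _ s (tdelta M) (tinit M) Some _ _ _ p nu tr); auto. apply run_val_resets.
    intros k Hk. destruct (H3 k Hk) as [G1 [G2 [Gd _]]]. unfold tr', p'.
    destruct (Nat.eqb_spec k (cs C)) as [Ek|Ek].
    + subst k. rewrite Nat.leb_refl. destruct (Nat.leb_spec0 (S (cs C)) (cs C)); [lia|].
      split. apply in_iter_delta. right; left. exists (tr (cs C)). split; auto. split; auto. congruence.
      simpl. split; auto. split. rewrite Gd; auto. split; auto. split.
      intros z; split; auto; intros _. apply (If _ G1). congruence.
      intros Hc; apply csat_cmap; auto.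
    + destruct (Nat.leb_spec0 k (cs C)); [lia|]. destruct (Nat.leb_spec0 (S k) (cs C)); [lia|].
      split. apply in_iter_delta. left. exists (tr k). split; auto.
      simpl. split. rewrite G2; auto. split. rewrite Gd; auto. split; auto. split.
      intros z; simpl; tauto. intros Hc; apply csat_cmap; auto.
  - unfold p'. destruct (Nat.leb_spec0 (S (ce C)) (cs C)); [lia|]. exact H4.
  - intros x k. rewrite H5. unfold tr'. destruct (Nat.eqb k (cs C)); simpl; tauto.
Qed.

Lemma iterA_bwd s C : valid_stream s -> fresh_start M ->
  iter_sem s adj I (semT M s) C -> semT (iterA M adj I) s C.
Proof. intros Hv If HI. induction HI as [C HC|C C1 C2 W HC1 _ IH Hgap Hint [U1 [U2 U3]]].
  { apply iterA_base; auto. }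
  assert (Ii := @iterA_fresh_start T A D X M adj I If).
  apply semT_iff in HC1. destruct HC1 as [W1 [p1 [nu1 [tr1 [H1 [H2 [H3 [H4 H5]]]]]]]].
  apply semT_iff in IH. destruct IH as [W2 [p2 [nu2 [tr2 [K1 [K2 [K3 [K4 K5]]]]]]]].
  destruct W1 as [A1 [A2 [A3 A4]]]. destruct W2 as [B1 [B2 [B3 B4]]].
  set (i1 := cs C1) in *. set (j1 := ce C1) in *. set (i2 := cs C2) in *. set (j2 := ce C2) in *.
  assert (Hg : j1 < i2) by (destruct adj; lia).
  assert (Ecs : cs C = i1) by (rewrite U1; lia). assert (Ece : ce C = j2) by (rewrite U2; lia).
  apply semT_iff. split; auto. rewrite Ecs, Ece.
  set (tr' := fun k => if Nat.leb k j1 then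
                 (if Nat.eqb k i1 then (if Nat.eqb i1 j1 then iter_single M (tr1 k) else iter_start M (tr1 k))
                  else if Nat.eqb k j1 then iter_last M (tr1 k) else iter_step M (tr1 k))
               else if Nat.ltb k i2 then iter_wait M
               else if Nat.eqb k i2 then restart M I (tr2 k) else tr2 k).
  set (p' := fun k => if Nat.leb k i1 then ItInit else if Nat.leb k j1 then ItIn (p1 k)
                      else if Nat.leb k i2 then ItGap else p2 k : Si).
  set (nu' := run_val s (fun _ : Zi => None) tr' i1).
  assert (Hr : follows_resets s nu' tr' i1 j2) by apply run_val_resets.
  assert (Ea : i1 = j1 -> tr' i1 = iter_single M (tr1 i1)).
  { intros E. unfold tr'. destruct (Nat.leb_spec0 i1 j1); [|lia]. rewrite Nat.eqb_refl. rewrite E, Nat.eqb_refl. reflexivity. }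
  assert (Eb : i1 < j1 -> tr' i1 = iter_start M (tr1 i1)).
  { intros E. unfold tr'. destruct (Nat.leb_spec0 i1 j1); [|lia]. rewrite Nat.eqb_refl.
    destruct (Nat.eqb_spec i1 j1); [lia|reflexivity]. }
  assert (Ec : forall k, i1 < k -> k = j1 -> tr' k = iter_last M (tr1 k)).
  { intros k E1 E2. unfold tr'. destruct (Nat.leb_spec0 k j1); [|lia]. destruct (Nat.eqb_spec k i1); [lia|].
    destruct (Nat.eqb_spec k j1); [reflexivity|lia]. }
  assert (Ed : forall k, i1 < k < j1 -> tr' k = iter_step M (tr1 k)).
  { intros k E1. unfold tr'. destruct (Nat.leb_spec0 k j1); [|lia]. destruct (Nat.eqb_spec k i1); [lia|].
    destruct (Nat.eqb_spec k j1); [lia|reflexivity]. }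
  assert (Ee : forall k, j1 < k < i2 -> tr' k = iter_wait M).
  { intros k E1. unfold tr'. destruct (Nat.leb_spec0 k j1); [lia|]. destruct (Nat.ltb_spec0 k i2); [reflexivity|lia]. }
  assert (Ef : tr' i2 = restart M I (tr2 i2)).
  { unfold tr'. destruct (Nat.leb_spec0 i2 j1); [lia|]. destruct (Nat.ltb_spec0 i2 i2); [lia|]. rewrite Nat.eqb_refl; reflexivity. }
  assert (Eg : forall k, i2 < k -> tr' k = tr2 k).
  { intros k E1. unfold tr'. destruct (Nat.leb_spec0 k j1); [lia|]. destruct (Nat.ltb_spec0 k i2); [lia|].
    destruct (Nat.eqb_spec k i2); [lia|reflexivity]. }
  assert (Pa : p' i1 = ItInit). { unfold p'. rewrite Nat.leb_refl. reflexivity. }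
  assert (Pb : forall k, i1 < k <= j1 -> p' k = ItIn (p1 k)).
  { intros k Hk. unfold p'. destruct (Nat.leb_spec0 k i1); [lia|]. destruct (Nat.leb_spec0 k j1); [reflexivity|lia]. }
  assert (Pc : forall k, j1 < k <= i2 -> p' k = ItGap).
  { intros k Hk. unfold p'. destruct (Nat.leb_spec0 k i1); [lia|]. destruct (Nat.leb_spec0 k j1); [lia|].
    destruct (Nat.leb_spec0 k i2); [reflexivity|lia]. }
  assert (Pd : forall k, i2 < k -> p' k = p2 k).
  { intros k Hk. unfold p'. destruct (Nat.leb_spec0 k i1); [lia|]. destruct (Nat.leb_spec0 k j1); [lia|].
    destruct (Nat.leb_spec0 k i2); [lia|reflexivity]. }
  assert (Hi2 : In (tr2 i2) iD /\ tsrc (tr2 i2) = ItInit).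
  { destruct (K3 i2 ltac:(lia)) as [G1 [G2 _]]. split; auto. rewrite G2, K1; reflexivity. }
  destruct (Ii _ (proj1 Hi2) (proj2 Hi2)) as [Ra Cf].
  assert (Hag : forall k, i2 < k <= S j2 -> forall z, nu' k z = nu2 k z).
  { intros k Hk z. apply (@clocks_agree T A D X _ _ _ _ s nu2 tr2 nu' tr' (fun z => z) i2 j2); auto.
    - eapply run_segment_resets; eauto.
    - eapply follows_resets_sub; [exact Hr|lia|lia].
    - intros k' Hk' z'. destruct (Nat.eq_dec k' i2) as [->|Ne]. rewrite Ef; simpl; tauto. rewrite Eg by lia; tauto. }
  exists p', nu', tr'. split; auto. split. intros z; unfold nu'; rewrite run_val_start; auto.
  split; [|split].
  - apply run_segment_app with j1.
    + apply (@run_segment_push T A D X _ _ _ _ s (tdelta M) (tinit M) Some _ _ _ p1 nu1 tr1); auto.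
      eapply follows_resets_sub; [exact Hr|lia|lia].
      intros k Hk. destruct (H3 k Hk) as [G1 [G2 [Gd _]]].
      destruct (Nat.eq_dec k i1) as [Ek|Ek]; [destruct (Nat.eq_dec i1 j1) as [Eij|Eij]|destruct (Nat.eq_dec k j1) as [Ekj|Ekj]].
      * subst k. rewrite (Ea Eij). split. apply in_iter_delta. right; right; right; left. exists (tr1 i1).
        split; auto. split; [split; [congruence|]|reflexivity]. rewrite Gd. rewrite Eij. exact H4.
        simpl. split; [auto|]. split. rewrite Pc by lia. reflexivity. split; auto. split.
        intros z; split; [intros _; apply (If _ G1); congruence|intros _; exact Logic.I].
        intros Hc; apply csat_cmap; auto.
      * subst k. rewrite (Eb ltac:(lia)). split. apply in_iter_delta. right; left. exists (tr1 i1).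
        split; auto. split; [congruence|reflexivity].
        simpl. split; [auto|]. split. rewrite Pb by lia. rewrite Gd; reflexivity. split; auto. split.
        intros z; split; [intros _; apply (If _ G1); congruence|intros _; exact Logic.I].
        intros Hc; apply csat_cmap; auto.
      * rewrite (Ec k ltac:(lia) Ekj). split. apply in_iter_delta. right; right; left. exists (tr1 k).
        split; auto. split; [|reflexivity]. rewrite Gd, Ekj. exact H4.
        simpl. split. rewrite Pb by lia. rewrite G2; reflexivity. split. rewrite Pc by lia. reflexivity. split; auto.
        split. intros z; simpl; split; [intros [HH|HH]; [exact HH|discriminate]|intros HH; left; exact HH].
        intros Hc; apply csat_cmap; auto.
      * rewrite (Ed k ltac:(lia)). split. apply in_iter_delta. left. exists (tr1 k). split; auto.
        simpl. split. rewrite Pb by lia. rewrite G2; reflexivity. split. rewrite Pb by lia. rewrite Gd; reflexivity.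
        split; auto. split. intros z; simpl; tauto. intros Hc; apply csat_cmap; auto.
    + apply run_segment_app with (i2 - 1).
      * intros k Hk. pose proof (Hr k ltac:(lia)) as HH. rewrite (Ee k ltac:(lia)) in HH |- *.
        split. apply in_iter_delta. right; right; right; right; right; right. split; auto. destruct adj; auto; lia.
        simpl. split. rewrite Pc by lia. reflexivity. split. rewrite Pc by lia. reflexivity.
        split. apply ev_sat_True. lia. split. split; [intros z []|exact Logic.I].
        exact HH.
      * replace (S (i2 - 1)) with i2 by lia.
        intros k Hk. destruct (K3 k Hk) as [G1 [G2 [Gd [G4 [G5 _]]]]]. pose proof (Hr k ltac:(lia)) as HR.
        destruct (Nat.eq_dec k i2) as [Ek|Ek].
        -- subst k. rewrite Ef in HR |- *. split.
           { apply in_iter_delta. destruct (@iter_delta_from_init T A D X M adj I _ G1 (proj2 Hi2)) as [[t0 [T0 [S0 E0]]]|[t0 [T0 [S0 E0]]]]; rewrite E0.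
             right; right; right; right; left. exists t0; auto.
             right; right; right; right; right; left. exists t0; auto. }
           simpl. split. rewrite Pc by lia. reflexivity. split. rewrite Pd by lia. exact Gd. split; auto.
           split; [|exact HR]. apply csat_and. split. eapply csat_clockless; [exact Cf|exact G5].
           assert (Hc' : vshift (nu' i2) (dt s i2) None = Some (Q2R (ts s i2 - ts s j1))).
           { apply (@clock_since_reset_shifted T A D X _ _ s nu' tr' j1 j2 None); [| |lia|].
             - eapply follows_resets_sub; [exact Hr|lia|lia].
             - destruct (Nat.eq_dec i1 j1) as [Eij|Eij].
               + rewrite <- Eij, (Ea Eij). simpl; auto.
               + rewrite (Ec j1 ltac:(lia) eq_refl). simpl; auto.
             - intros m Hm. rewrite (Ee m Hm). simpl; auto. }
           apply (csat_interval_guard I None _ Hc'); auto. apply Qsub_ge0. apply ts_le; auto; lia.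
        -- rewrite (Eg k ltac:(lia)) in HR |- *. split; auto. split. rewrite Pd by lia; auto.
           split. rewrite Pd by lia; auto. split; auto. split; [|exact HR].
           replace (nu' k) with (nu2 k); auto. extensionality z. symmetry; apply Hag; lia.
  - rewrite Pd by lia. exact K4.
  - intros x k. rewrite U3, H5, K5.
    destruct (Nat.le_gt_cases k j1).
    + destruct (Nat.eq_dec k i1) as [Ek|Ek]; [destruct (Nat.eq_dec i1 j1) as [Eij|Eij]|destruct (Nat.eq_dec k j1) as [Ekj|Ekj]].
      * subst k. rewrite (Ea Eij). simpl. split; [intros [[Hk Hl]|[Hk Hl]]; [split; [lia|auto]|lia]|intros [Hk Hl]; left; split; [lia|auto]].
      * subst k. rewrite (Eb ltac:(lia)). simpl. split; [intros [[Hk Hl]|[Hk Hl]]; [split; [lia|auto]|lia]|intros [Hk Hl]; left; split; [lia|auto]].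
      * destruct (Nat.le_gt_cases i1 k); [|split; [intros [[Hk Hl]|[Hk Hl]]; lia|intros [Hk Hl]; lia]].
        rewrite (Ec k ltac:(lia) Ekj). simpl. split; [intros [[Hk Hl]|[Hk Hl]]; [split; [lia|auto]|lia]|intros [Hk Hl]; left; split; [lia|auto]].
      * destruct (Nat.le_gt_cases i1 k); [|split; [intros [[Hk Hl]|[Hk Hl]]; lia|intros [Hk Hl]; lia]].
        rewrite (Ed k ltac:(lia)). simpl. split; [intros [[Hk Hl]|[Hk Hl]]; [split; [lia|auto]|lia]|intros [Hk Hl]; left; split; [lia|auto]].
    + destruct (Nat.lt_ge_cases k i2).
      * rewrite (Ee k ltac:(lia)). simpl. split; [intros [[Hk Hl]|[Hk Hl]]; lia|intros [Hk []]].
      * destruct (Nat.eq_dec k i2) as [Ek|Ek].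
        -- subst k. rewrite Ef. simpl. split; [intros [[Hk Hl]|[Hk Hl]]; [lia|split; [lia|auto]]|intros [Hk Hl]; right; split; [lia|auto]].
        -- rewrite (Eg k ltac:(lia)). simpl. split; [intros [[Hk Hl]|[Hk Hl]]; [lia|split; [lia|auto]]|intros [Hk Hl]; right; split; [lia|auto]].
Qed.

End Part12.


Section Part13.
Variables T A D X : Type.
Notation TA := (TCEA T A D X).
Variables (M : TA) (adj : bool) (I : interval).
Notation Zi := (option (tclk M)).
Notation Si := (iter_state (tst M)).
Notation TrM := (trans T A D X (tst M) (tclk M)).
Notation TrI := (trans T A D X Si Zi).
Notation iD := (iter_delta M adj I).

Lemma iterA_fwd s : valid_stream s -> fresh_start M ->
  forall C, semT (iterA M adj I) s C -> iter_sem s adj I (semT M s) C.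
Proof. intros Hv If C. remember (ce C - cs C) as d eqn:Ed. revert C Ed.
  induction d as [d IH] using (well_founded_induction Wf_nat.lt_wf). intros C Ed HC.
  assert (Ii := @iterA_fresh_start T A D X M adj I If).
  pose proof HC as HC0. apply semT_iff in HC.
  destruct HC as [W [p' [nu' [tr' [H1 [H2 [H3 [H4 H5]]]]]]]].
  pose proof W as W0. destruct W as [W1 [W2 [W3 W4]]]. simpl in H1, H4.
  set (i := cs C) in *. set (j := ce C) in *.
  destruct (classic (exists m, i <= m <= j /\ p' (S m) = ItGap)) as [Hex|NA].
  2: {
    apply it_base.
    assert (HLa : forall k, i < k <= S j -> exists a, p' k = ItIn a).
    { intros k Hk. induction k. lia. destruct (H3 k ltac:(lia)) as [K1 [K2 [K3 _]]].
      destruct (Nat.eq_dec k i) as [->|Ne].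
      - rewrite H1 in K2. destruct (@iter_delta_from_init T A D X M adj I _ K1 K2) as [[t0 [_ [_ E]]]|[t0 [_ [_ E]]]]; rewrite E in K3; simpl in K3.
        + eexists; eauto.
        + exfalso; apply NA; exists i; split; [lia|]. rewrite <- K3; reflexivity.
      - destruct IHk as [a Ha]. lia. rewrite Ha in K2.
        destruct (@iter_delta_from_in T A D X M adj I _ _ K1 K2) as [[t0 [_ E]]|[t0 [_ [_ E]]]]; rewrite E in K3; simpl in K3.
        + eexists; eauto.
        + exfalso; apply NA; exists k; split; [lia|]. rewrite <- K3; reflexivity. }
    destruct (@run_segment_pull T A D X _ _ _ _ s (tdelta M) (tinit M) (idle_trans M) ItIn Some (fun t' t0 => tdst t' = ItIn (tdst t0))
       iD i j p' nu' tr' If ltac:(intros q1 q2 Eq; inversion Eq; auto) W2 H3) as [p [nu [tr [P1 [P2 [P3 [P4 P5]]]]]]].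
    { intros k Hk. destruct (H3 k Hk) as [K1 [K2 [K3 _]]].
      destruct (Nat.eq_dec k i) as [->|Ne].
      - rewrite H1 in K2. destruct (@iter_delta_from_init T A D X M adj I _ K1 K2) as [[t0 [G [Hs E]]]|[t0 [G [_ E]]]]; rewrite E in K3 |- *;
          simpl in K3.
        2: { exfalso; apply NA; exists i; split; [lia|]. rewrite <- K3; reflexivity. }
        exists t0; split; auto. unfold simulates; simpl.
        refine (conj (fun e He => He) (conj (fun x => iff_refl _) (conj _ (conj _ (conj _ (conj _ (conj _ _))))))).
        + intros nu0 Hc; apply csat_cmap; exact Hc.
        + intros z; split; [intros _; apply (If t0 G Hs)|intros _; exact Logic.I].
        + intros _; exact Hs.
        + intros; lia.
        + intros _; reflexivity.
        + intros _; reflexivity.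
      - destruct (HLa k ltac:(lia)) as [a Ha]. rewrite Ha in K2.
        destruct (@iter_delta_from_in T A D X M adj I _ _ K1 K2) as [[t0 [G E]]|[t0 [G [_ E]]]]; rewrite E in K3 |- *; simpl in K3.
        2: { exfalso; apply NA; exists k; split; [lia|]. rewrite <- K3; reflexivity. }
        exists t0; split; auto. unfold simulates; simpl.
        refine (conj (fun e He => He) (conj (fun x => iff_refl _) (conj _ (conj _ (conj _ (conj _ (conj _ _))))))).
        + intros nu0 Hc; apply csat_cmap; exact Hc.
        + intros z; apply iff_refl.
        + intros; lia.
        + intros _; reflexivity.
        + intros _; reflexivity.
        + intros _; reflexivity. }
    apply semT_iff. split; auto. fold i j. exists p, nu, tr. split; auto. split; auto. split; auto. split.
    + rewrite P4. destruct (P5 j ltac:(lia)) as [_ [_ [_ [_ [_ [_ [_ [_ Q]]]]]]]].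
      destruct (H3 j ltac:(lia)) as [_ [_ [K3 _]]].
      assert (Q' : p' (S j) = ItIn (tdst (tr j))) by (rewrite <- K3; exact (Q eq_refl)).
      rewrite Q' in H4. exact H4.
    + intros x k. rewrite H5. destruct (pdec (i <= k <= j)) as [Hk|Hk]; [|tauto].
      destruct (P5 k Hk) as [_ [_ [Q _]]]. rewrite Q. tauto. }
  destruct (least_witness _ Hex) as [m [[Hm1 Hm2] Hmin]].
  assert (HL : forall k, i < k <= m -> exists a, p' k = ItIn a).
  { intros k Hk. induction k. lia. destruct (H3 k ltac:(lia)) as [K1 [K2 [K3 _]]].
    destruct (Nat.eq_dec k i) as [->|Ne].
    - rewrite H1 in K2. destruct (@iter_delta_from_init T A D X M adj I _ K1 K2) as [[t0 [_ [_ E]]]|[t0 [_ [_ E]]]]; rewrite E in K3; simpl in K3.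
      + eexists; eauto.
      + exfalso; apply (Hmin i); [lia|]. split; [lia|]. rewrite <- K3; reflexivity.
    - destruct IHk as [a Ha]. lia. rewrite Ha in K2.
      destruct (@iter_delta_from_in T A D X M adj I _ _ K1 K2) as [[t0 [_ E]]|[t0 [_ [_ E]]]]; rewrite E in K3; simpl in K3.
      + eexists; eauto.
      + exfalso; apply (Hmin k); [lia|]. split; [lia|]. rewrite <- K3; reflexivity. }
  assert (Hmj : m < j). { destruct (Nat.eq_dec m j); [|lia]. subst m. rewrite Hm2 in H4. destruct H4. }
  assert (Hex2 : exists n, m < n <= j /\ tr' n <> iter_wait M).
  { apply NNPP. intros NB.
    assert (HGa : forall k, m < k <= S j -> p' k = ItGap).
    { intros k Hk. induction k. lia. destruct (Nat.eq_dec k m) as [->|Ne]. exact Hm2.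
      destruct (H3 k ltac:(lia)) as [_ [_ [K3 _]]]. rewrite <- K3.
      assert (E : tr' k = iter_wait M). { apply NNPP. intros Hne. apply NB. exists k. split; [lia|auto]. }
      rewrite E. reflexivity. }
    rewrite (HGa (S j) ltac:(lia)) in H4. exact H4. }
  destruct (least_witness _ Hex2) as [n [[Hn1 Hn2] Hnmin]].
  assert (HLp : forall k, m < k < n -> tr' k = iter_wait M).
  { intros k Hk. apply NNPP. intros Hne. apply (Hnmin k); [lia|]. split; [lia|auto]. }
  assert (HG : forall k, m < k <= n -> p' k = ItGap).
  { intros k Hk. induction k. lia. destruct (Nat.eq_dec k m) as [->|Ne]. exact Hm2.
    destruct (H3 k ltac:(lia)) as [_ [_ [K3 _]]]. rewrite <- K3. rewrite (HLp k ltac:(lia)). reflexivity. }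
  assert (HLoop : forall k, m < k < n -> adj = false).
  { intros k Hk. destruct (H3 k ltac:(lia)) as [K1 [K2 _]]. rewrite (HLp k Hk) in K1.
    apply in_iter_delta in K1.
    destruct K1 as [[t0 [_ E]]|[[t0 [_ [_ E]]]|[[t0 [_ [_ E]]]|[[t0 [_ [_ E]]]|[[t0 [_ [_ E]]]|[[t0 [_ [_ E]]]|[E' _]]]]]]];
      try (unfold iter_wait in E; discriminate E); auto. }
  assert (Hn : exists cn, In cn iD /\ tsrc cn = ItInit /\ tr' n = restart M I cn).
  { destruct (H3 n ltac:(lia)) as [K1 [K2 _]]. rewrite (HG n ltac:(lia)) in K2.
    destruct (@iter_delta_from_gap T A D X M adj I _ K1 K2) as [[t0 [G [Hs E]]]|[[t0 [G [Hs E]]]|[_ E]]].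
    - exists (iter_start M t0). split; [|split; auto]. apply in_iter_delta. right; left. exists t0; auto.
    - exists (iter_single M t0). split; [|split; auto]. apply in_iter_delta. right; right; right; left. exists t0; auto.
    - contradiction. }
  destruct Hn as [cn [Gn [Sn En]]].
  destruct (Ii cn Gn Sn) as [Rn Cn].
 
  assert (HKf : forall k, i <= k <= m -> exists t0, In t0 (tdelta M) /\
     ((k = i /\ k < m /\ tr' k = iter_start M t0 /\ tsrc t0 = tinit M) \/
      (k = i /\ k = m /\ tr' k = iter_single M t0 /\ (tsrc t0 = tinit M /\ tfinal M (tdst t0))) \/
      (i < k /\ k < m /\ tr' k = iter_step M t0) \/
      (i < k /\ k = m /\ tr' k = iter_last M t0 /\ tfinal M (tdst t0)))).
  { intros k Hk. destruct (H3 k ltac:(lia)) as [K1 [K2 [K3 _]]].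
    destruct (Nat.eq_dec k i) as [->|Ne].
    - rewrite H1 in K2. destruct (@iter_delta_from_init T A D X M adj I _ K1 K2) as [[t0 [G [Es E]]]|[t0 [G [Es E]]]]; exists t0; split; auto;
        rewrite E in K3; simpl in K3.
      + left. destruct (Nat.eq_dec i m) as [Eq|Nq]; [|split; [auto|split; [lia|auto]]].
        rewrite Eq in K3. rewrite Hm2 in K3. discriminate.
      + right; left. destruct (Nat.eq_dec i m) as [Eq|Nq]; [split; auto|].
        destruct (HL (S i) ltac:(lia)) as [a Ha]. rewrite Ha in K3; discriminate.
    - destruct (HL k ltac:(lia)) as [a Ha]. rewrite Ha in K2.
      destruct (@iter_delta_from_in T A D X M adj I _ _ K1 K2) as [[t0 [G E]]|[t0 [G [Ef E]]]]; exists t0; split; auto; rewrite E in K3; simpl in K3.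
      + right; right; left. destruct (Nat.eq_dec k m) as [Eq|Nq]; [|split; [lia|split; [lia|auto]]].
        rewrite Eq in K3. rewrite Hm2 in K3. discriminate.
      + right; right; right. destruct (Nat.eq_dec k m) as [Eq|Nq]; [split; [lia|auto]|].
        destruct (HL (S k) ltac:(lia)) as [a' Ha']. rewrite Ha' in K3; discriminate. }
  destruct (@run_segment_pull T A D X _ _ _ _ s (tdelta M) (tinit M) (idle_trans M) ItIn Some (fun _ t0 => tfinal M (tdst t0))
       iD i m p' nu' tr' If ltac:(intros q1 q2 Eq; inversion Eq; auto) (proj1 Hm1)
       ltac:(intros k Hk; apply H3; lia)) as [p1 [nu1 [tr1 [P1 [P2 [P3 [P4 P5]]]]]]].
  { intros k Hk. destruct (HKf k Hk) as [t0 [G HH]]. exists t0. split; auto.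
    destruct HH as [[Ek [Hl [E Hs]]]|[[Ek [Ek' [E Hs]]]|[[Hl [Hr E]]|[Hl [Ek [E Hf]]]]]]; rewrite E; unfold simulates; simpl;
      refine (conj (fun e He => He) (conj (fun x => iff_refl _) (conj _ (conj _ (conj _ (conj _ (conj _ _))))))).
    - intros nu0 Hc; apply csat_cmap; exact Hc.
    - intros z; split; [intros _; apply (If t0 G Hs)|intros _; exact Logic.I].
    - intros _; exact Hs.
    - intros; lia.
    - intros _; reflexivity.
    - intros; lia.
    - intros nu0 Hc; apply csat_cmap; exact Hc.
    - intros z; split; [intros _; apply (If t0 G (proj1 Hs))|intros _; exact Logic.I].
    - intros _; apply Hs.
    - intros; lia.
    - intros; lia.
    - intros _; apply Hs.
    - intros nu0 Hc; apply csat_cmap; exact Hc.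
    - intros z; apply iff_refl.
    - intros; lia.
    - intros _; reflexivity.
    - intros _; reflexivity.
    - intros; lia.
    - intros nu0 Hc; apply csat_cmap; exact Hc.
    - intros z; simpl; split; [intros [H|H]; [exact H|discriminate]|intros H; left; exact H].
    - intros; lia.
    - intros _; reflexivity.
    - intros; lia.
    - intros _; exact Hf. }
 
  set (C2 := mkCE n j (fun x k => n <= k <= j /\ tlab (tr' k) x)).
  assert (HC2 : semT (iterA M adj I) s C2).
  { apply semT_iff. split. split; simpl; [lia|split; [lia|split; [lia|]]]. intros x k [Hk _]; exact Hk.
    set (tr'' := fun k => if Nat.eqb k n then cn else tr' k).
    set (p'' := fun k => if Nat.eqb k n then ItInit else p' k).
    set (nu'' := run_val s (fun _ : Zi => None) tr'' n).
    assert (Hr : follows_resets s nu'' tr'' n j) by apply run_val_resets.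
    assert (Hag : forall k, n < k <= S j -> forall z, nu'' k z = nu' k z).
    { intros k Hk z. apply (@clocks_agree T A D X _ _ _ _ s nu' tr' nu'' tr'' (fun z => z) n j); auto.
      - eapply follows_resets_sub; [eapply run_segment_resets; exact H3|lia|lia].
      - intros k' Hk' z'. unfold tr''. destruct (Nat.eqb_spec k' n) as [->|Ne]; [rewrite En; simpl; tauto|tauto].
      - intros z'. rewrite En. simpl. apply Rn. }
    exists p'', nu'', tr''. simpl. split. unfold p''; rewrite Nat.eqb_refl; reflexivity.
    split. intros z; unfold nu''; rewrite run_val_start; auto.
    split; [|split].
    - intros k Hk. destruct (H3 k ltac:(lia)) as [G1 [G2 [Gd [G4 [G5 _]]]]].
      pose proof (Hr k Hk) as HR. unfold tr'', p'' in *.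
      destruct (Nat.eqb_spec k n) as [Ek|Ek].
      + subst k. destruct (Nat.eqb_spec (S n) n); [lia|].
        rewrite En in Gd, G4, G5. simpl in Gd, G4, G5.
        split; auto. split; auto. split; auto. split; auto. split; [|exact HR].
        apply csat_and in G5. eapply csat_clockless; [exact Cn|apply G5].
      + destruct (Nat.eqb_spec (S k) n); [lia|].
        split; auto. split; auto. split; auto. split; auto. split; [|exact HR].
        replace (nu'' k) with (nu' k); auto. extensionality z. symmetry; apply Hag; lia.
    - unfold p''. destruct (Nat.eqb_spec (S j) n); [lia|]. exact H4.
    - intros x k. unfold tr''. destruct (Nat.eqb_spec k n) as [->|Ne]; [rewrite En; simpl; tauto|tauto]. }
  assert (IH2 : iter_sem s adj I (semT M s) C2).
  { apply (IH (j - n)); [|reflexivity|exact HC2]. unfold i, j in *. lia. }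
  apply (@it_step T A D X s adj I (semT M s) C (mkCE i m (fun x k => i <= k <= m /\ tlab (tr' k) x)) C2 W0); auto.
  - apply semT_iff. split. split; simpl; [lia|split; [lia|split; [lia|]]]. intros x k [Hk _]; exact Hk.
    exists p1, nu1, tr1. simpl. split; auto. split; auto. split; auto. split.
    + rewrite P4. apply (P5 m ltac:(lia)); auto.
    + intros x k. destruct (pdec (i <= k <= m)) as [Hk|Hk]; [|tauto].
      destruct (P5 k Hk) as [_ [_ [Q _]]]. rewrite Q. tauto.
  - simpl. destruct adj eqn:Ea; [|lia]. destruct (Nat.eq_dec n (S m)); [lia|].
    specialize (HLoop (S m) ltac:(lia)). discriminate.
  - simpl. assert (Hc : vshift (nu' n) (dt s n) None = Some (Q2R (ts s n - ts s m))).
    { apply (@clock_since_reset_shifted T A D X _ _ s nu' tr' m j None); [| |lia|].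
      - eapply follows_resets_sub; [eapply run_segment_resets; exact H3| lia | lia].
      - destruct (HKf m ltac:(lia)) as [t1 [_ HH]].
        destruct HH as [[_ [Hx _]]|[[_ [_ [E' _]]]|[[_ [Hx _]]|[_ [_ [E' _]]]]]]; try lia; rewrite E'; simpl; auto.
      - intros k Hk. rewrite (HLp k Hk); simpl; auto. }
    destruct (H3 n ltac:(lia)) as [_ [_ [_ [_ [Hg _]]]]]. rewrite En in Hg. simpl in Hg.
    apply csat_and in Hg. destruct Hg as [_ Hg].
    apply (csat_interval_guard I None _ Hc); auto. apply Qsub_ge0. apply ts_le; auto; lia.
  - split; [simpl; lia|split; [simpl; lia|]]. intros x k. rewrite H5. simpl.
    destruct (Nat.le_gt_cases k m).
    { split; [intros [Hk Hl]; left; split; [lia|auto] | intros [[Hk Hl]|[Hk Hl]]; split; auto; lia]. }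
    destruct (Nat.le_gt_cases n k).
    { split; [intros [Hk Hl]; right; split; [lia|auto] | intros [[Hk Hl]|[Hk Hl]]; split; auto; lia]. }
    split; [|intros [[Hk Hl]|[Hk Hl]]; lia]. intros [Hk Hl]. rewrite (HLp k ltac:(lia)) in Hl. destruct Hl.
Qed.

End Part13.


Definition Inonneg : interval := mkInterval 0%Q true None.

Lemma in_Inonneg d : in_interval Inonneg d <-> (0 <= d)%Q.
Proof. unfold in_interval, Inonneg; simpl. tauto. Qed.

Section Part14.
Variables T A D X : Type.
Variable inj : T -> X.

Lemma sem_wf (s : tstream T A D) (f : formula T A D X) C : sem inj s f C -> wfCE s C.
Proof. intros H; induction H; auto. Qed.

Lemma gap_nonneg (s : tstream T A D) (C1 C2 : CE X) : valid_stream s -> wfCE s C1 -> wfCE s C2 -> ce C1 < cs C2 ->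
  in_interval Inonneg (ts s (cs C2) - ts s (ce C1))%Q.
Proof. intros Hv [A1 [A2 [A3 _]]] [B1 [B2 [B3 _]]] H. apply in_Inonneg. apply Qsub_ge0. apply ts_le; auto; lia. Qed.

Lemma seq_sem_ext (s : tstream T A D) adj I (S1 S1' S2 S2' : CE X -> Prop) C :
  (forall C, S1 C <-> S1' C) -> (forall C, S2 C <-> S2' C) ->
  (seq_sem s adj I S1 S2 C <-> seq_sem s adj I S1' S2' C).
Proof. intros E1 E2. unfold seq_sem. split; intros [W [C1 [C2 [H1 [H2 H3]]]]]; split; auto; exists C1, C2;
  [rewrite <- E1, <- E2|rewrite E1, E2]; auto. Qed.

Lemma iter_sem_ext (s : tstream T A D) adj I (S1 S2 : CE X -> Prop) C :
  (forall C, S1 C <-> S2 C) -> (iter_sem s adj I S1 C <-> iter_sem s adj I S2 C).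
Proof. intros E. split; intros H; induction H.
  - apply it_base. apply E; auto.
  - eapply it_step; eauto. apply E; auto.
  - apply it_base. apply E; auto.
  - eapply it_step; eauto. apply E; auto. Qed.

Lemma sem_seqI (s : tstream T A D) f I g C : sem inj s (FSeqI f I g) C <-> seq_sem s false I (sem inj s f) (sem inj s g) C.
Proof. split.
  - intros H. inversion H; subst. split; auto. exists C1, C2; auto.
  - intros [W [C1 [C2 [H1 [H2 [H3 [H4 H5]]]]]]]. eapply sem_seqI; eauto. Qed.

Lemma sem_consI (s : tstream T A D) f I g C : sem inj s (FConsI f I g) C <-> seq_sem s true I (sem inj s f) (sem inj s g) C.
Proof. split.
  - intros H. inversion H; subst. split; auto. exists C1, C2; auto.
  - intros [W [C1 [C2 [H1 [H2 [H3 [H4 H5]]]]]]]. eapply sem_consI; eauto. Qed.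

Lemma sem_seq (s : tstream T A D) f g C : valid_stream s -> (sem inj s (FSeq f g) C <-> seq_sem s false Inonneg (sem inj s f) (sem inj s g) C).
Proof. intros Hv. split.
  - intros H. inversion H; subst. split; auto. exists C1, C2. repeat (split; auto).
    apply gap_nonneg; auto; eapply sem_wf; eauto.
  - intros [W [C1 [C2 [H1 [H2 [H3 [H4 H5]]]]]]]. eapply sem_seq; eauto. Qed.

Lemma sem_cons (s : tstream T A D) f g C : valid_stream s -> (sem inj s (FCons f g) C <-> seq_sem s true Inonneg (sem inj s f) (sem inj s g) C).
Proof. intros Hv. split.
  - intros H. inversion H; subst. split; auto. exists C1, C2. repeat (split; auto).
    apply gap_nonneg; auto; try (eapply sem_wf; eauto). simpl in *; lia.
  - intros [W [C1 [C2 [H1 [H2 [H3 [H4 H5]]]]]]]. eapply sem_cons; eauto. Qed.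

Lemma sem_plusI (s : tstream T A D) f I C : sem inj s (FPlusI f I) C <-> iter_sem s false I (sem inj s f) C.
Proof. split.
  - intros H. remember (FPlusI f I) as phi eqn:Ephi. induction H; inversion Ephi; subst.
    + apply it_base; auto.
    + eapply it_step; eauto.
  - intros H. induction H. apply sem_plusI_base; auto. eapply sem_plusI_step; eauto. Qed.

Lemma sem_oplusI (s : tstream T A D) f I C : sem inj s (FOplusI f I) C <-> iter_sem s true I (sem inj s f) C.
Proof. split.
  - intros H. remember (FOplusI f I) as phi eqn:Ephi. induction H; inversion Ephi; subst.
    + apply it_base; auto.
    + eapply it_step; eauto.
  - intros H. induction H. apply sem_oplusI_base; auto. eapply sem_oplusI_step; eauto. Qed.

Lemma sem_plus (s : tstream T A D) f C : valid_stream s -> (sem inj s (FPlus f) C <-> iter_sem s false Inonneg (sem inj s f) C).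
Proof. intros Hv. split.
  - intros H. remember (FPlus f) as phi eqn:Ephi. induction H; inversion Ephi; subst.
    + apply it_base; auto.
    + eapply it_step; eauto. apply gap_nonneg; auto; eapply sem_wf; eauto.
  - intros H. induction H. apply sem_plus_base; auto. eapply sem_plus_step; eauto. Qed.

Lemma sem_oplus (s : tstream T A D) f C : valid_stream s -> (sem inj s (FOplus f) C <-> iter_sem s true Inonneg (sem inj s f) C).
Proof. intros Hv. split.
  - intros H. remember (FOplus f) as phi eqn:Ephi. induction H; inversion Ephi; subst.
    + apply it_base; auto.
    + eapply it_step; eauto. apply gap_nonneg; auto; try (eapply sem_wf; eauto). lia.
  - intros H. induction H. apply sem_oplus_base; auto. eapply sem_oplus_step; eauto. Qed.

Definition as_labels (x : X) (L : X -> Prop) (z : X) : Prop := (z = x /\ exists y, L y) \/ (z <> x /\ L z).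
Definition proj_labels (Lp : X -> Prop) (L : X -> Prop) (z : X) : Prop := Lp z /\ L z.

Lemma as_labels_ext x : forall L1 L2, (forall y, L1 y <-> L2 y) -> forall z, as_labels x L1 z <-> as_labels x L2 z.
Proof. intros L1 L2 E z. unfold as_labels. split; intros [[H1 [y Hy]]|[H1 H2]]; [left|right|left|right];
  split; auto; try (exists y; apply E; auto); apply E; auto. Qed.
Lemma as_labels_empty x z : ~ as_labels x (fun _ => False) z.
Proof. unfold as_labels. intros [[_ [_ []]]|[_ []]]. Qed.
Lemma proj_labels_ext Lp : forall L1 L2, (forall y, L1 y <-> L2 y) -> forall z, proj_labels Lp L1 z <-> proj_labels Lp L2 z.
Proof. intros L1 L2 E z. unfold proj_labels. rewrite E. tauto. Qed.
Lemma proj_labels_empty Lp z : ~ proj_labels Lp (fun _ => False) z.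
Proof. unfold proj_labels. tauto. Qed.

Lemma sem_as (s : tstream T A D) f x C : sem inj s (FAs f x) C <-> wfCE s C /\ exists C', sem inj s f C' /\ cs C' = cs C /\ ce C' = ce C /\
       forall z k, cmu C z k <-> as_labels x (fun y => cmu C' y k) z.
Proof. split.
  - intros H. inversion H; subst. split; auto. exists C'. split; auto. split; auto. split; auto.
    intros z k. unfold as_labels. destruct (classic (z = x)) as [->|Ne].
    + rewrite H6. split; [intros Hy; left; auto|intros [[_ Hy]|[Hn _]]; auto; contradiction].
    + rewrite H8 by auto. split; [intros Hy; right; auto|intros [[Hz _]|[_ Hy]]; auto; contradiction].
  - intros [W [C' [H1 [H2 [H3 H4]]]]]. eapply sem_as; eauto.
    + intros k. rewrite H4. unfold as_labels. split; [intros [[_ Hy]|[Hn _]]; auto; contradiction|intros Hy; left; auto].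
    + intros z k Hz. rewrite H4. unfold as_labels. split; [intros [[Hz' _]|[_ Hy]]; auto; contradiction|intros Hy; right; auto].
Qed.

Lemma sem_proj (s : tstream T A D) L f C : sem inj s (FProj L f) C <-> wfCE s C /\ exists C', sem inj s f C' /\ cs C' = cs C /\ ce C' = ce C /\
       forall z k, cmu C z k <-> proj_labels L (fun y => cmu C' y k) z.
Proof. split.
  - intros H. inversion H; subst. split; auto. exists C'. split; auto.
  - intros [W [C' [H1 [H2 [H3 H4]]]]]. eapply sem_proj; eauto. Qed.

Lemma sem_filter (s : tstream T A D) f x P C : sem inj s (FFilter f x P) C <-> sem inj s f C /\ forall k, cmu C x k -> ev_sat s k P.
Proof. split. intros H; inversion H; subst; auto. intros [H1 H2]; apply sem_filter; auto. Qed.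

Lemma sem_or (s : tstream T A D) f g C : sem inj s (FOr f g) C <-> sem inj s f C \/ sem inj s g C.
Proof. split. intros H; inversion H; subst; auto. intros [H|H]; [apply sem_or_l|apply sem_or_r]; auto. Qed.

Lemma sem_and (s : tstream T A D) f g C : sem inj s (FAnd f g) C <-> sem inj s f C /\ sem inj s g C.
Proof. split. intros H; inversion H; subst; auto. intros [H1 H2]; apply sem_and; auto. Qed.

Lemma sem_win (s : tstream T A D) f I C : sem inj s (FWin f I) C <-> sem inj s f C /\ in_interval I (ts s (ce C) - ts s (cs C))%Q.
Proof. split. intros H; inversion H; subst; auto. intros [H1 H2]; apply sem_win; auto. Qed.

End Part14.


Section Part15.
Variables T A D X : Type.
Variable inj : T -> X.
Variable Pset : (Event T A D -> Prop) -> Prop.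
Hypothesis Pset_E : Pset (fun _ => True).
Hypothesis Pset_inter : forall P1 P2, Pset P1 -> Pset P2 -> Pset (fun e => P1 e /\ P2 e).
Hypothesis Pset_type : forall R : T, Pset (fun e => etype e = R).

Definition realizable (phi : formula T A D X) :=
  exists M : TCEA T A D X, tcea_ok Pset M /\ fresh_start M /\
    forall s, valid_stream s -> forall C, sem inj s phi C <-> semT M s C.

Lemma realizable_seq f g phi adj I : realizable f -> realizable g ->
  (forall s, valid_stream s -> forall C, sem inj s phi C <-> seq_sem s adj I (sem inj s f) (sem inj s g) C) ->
  realizable phi.
Proof. intros [Mf [Of [If Sf]]] [Mg [Og [Ig Sg]]] H. exists (seqA Mf Mg adj I). split; [|split].
  - apply seqA_ok; auto.
  - apply seqA_fresh_start; auto.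
  - intros s Hv C. rewrite H by auto. rewrite (@seq_sem_ext T A D X s adj I _ (semT Mf s) _ (semT Mg s)).
    split. apply seqA_bwd; auto. apply seqA_fwd; auto.
    intros; apply Sf; auto. intros; apply Sg; auto. Qed.

Lemma realizable_iter f phi adj I : realizable f ->
  (forall s, valid_stream s -> forall C, sem inj s phi C <-> iter_sem s adj I (sem inj s f) C) ->
  realizable phi.
Proof. intros [Mf [Of [If Sf]]] H. exists (iterA Mf adj I). split; [|split].
  - apply iterA_ok; auto.
  - apply iterA_fresh_start; auto.
  - intros s Hv C. rewrite H by auto. rewrite (@iter_sem_ext T A D X s adj I _ (semT Mf s)).
    split. apply iterA_bwd; auto. apply iterA_fwd; auto.
    intros; apply Sf; auto. Qed.

Lemma realizable_relabel f phi F : realizable f ->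
  (forall L1 L2, (forall y, L1 y <-> L2 y) -> forall z, F L1 z <-> F L2 z) ->
  (forall z, ~ F (fun _ => False) z) ->
  (forall s, valid_stream s -> forall C, sem inj s phi C <-> wfCE s C /\ exists C', sem inj s f C' /\ cs C' = cs C /\ ce C' = ce C /\
       forall z k, cmu C z k <-> F (fun y => cmu C' y k) z) ->
  realizable phi.
Proof. intros [Mf [Of [If Sf]]] Fe F0 H. exists (relabelA F Mf). split; [|split].
  - apply mapA_ok; auto; intros; simpl; auto.
  - apply mapA_fresh_start; auto; intros; simpl; auto.
  - intros s Hv C. rewrite H by auto. rewrite relabelA_spec by auto.
    split; intros [W [C' [H1 H2]]]; split; auto; exists C'; split; auto; apply Sf; auto. Qed.

Theorem formula_realizable (phi : formula T A D X) : formula_preds_in Pset phi -> realizable phi.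
Proof. induction phi; simpl; intros Hp.
  - match goal with R0 : T |- _ => exists (@atomA T A D X inj R0) end. split; [apply atomA_ok; auto|split; [apply atomA_fresh_start|]].
    intros s Hv C. rewrite atomA_spec. tauto.
  - apply realizable_relabel with (f := phi) (F := as_labels x); auto. apply as_labels_ext. apply as_labels_empty. intros s Hv C. apply sem_as.
  - destruct Hp as [HP Hf]. destruct (IHphi Hf) as [Mf [Of [If Sf]]].
    exists (filterA x P Mf). split; [|split].
    + apply mapA_ok; [intros; simpl; auto| |auto]. intros t0 Ht. simpl. destruct (pdec (tlab t0 x)); auto.
    + apply mapA_fresh_start; auto; intros; simpl; auto.
    + intros s Hv C. rewrite sem_filter, filterA_spec, Sf by auto. tauto.
  - destruct Hp as [H1 H2]. destruct (IHphi1 H1) as [Mf [Of [If Sf]]]. destruct (IHphi2 H2) as [Mg [Og [Ig Sg]]].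
    exists (orA Mf Mg). split; [apply orA_ok; auto|split; [apply orA_fresh_start; auto|]].
    intros s Hv C. rewrite sem_or, orA_spec, Sf, Sg by auto. tauto.
  - destruct Hp as [H1 H2]. destruct (IHphi1 H1) as [Mf [Of [If Sf]]]. destruct (IHphi2 H2) as [Mg [Og [Ig Sg]]].
    exists (andA Mf Mg). split; [apply andA_ok; auto|split; [apply andA_fresh_start; auto|]].
    intros s Hv C. rewrite sem_and, andA_spec, Sf, Sg by auto. tauto.
  - destruct Hp as [H1 H2]. apply realizable_seq with (f := phi1) (g := phi2) (adj := false) (I := Inonneg); auto. intros s Hv C; apply sem_seq; auto.
  - destruct Hp as [H1 H2]. apply realizable_seq with (f := phi1) (g := phi2) (adj := true) (I := Inonneg); auto. intros s Hv C; apply sem_cons; auto.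
  - apply realizable_iter with (f := phi) (adj := false) (I := Inonneg); auto. intros s Hv C; apply sem_plus; auto.
  - apply realizable_iter with (f := phi) (adj := true) (I := Inonneg); auto. intros s Hv C; apply sem_oplus; auto.
  - apply realizable_relabel with (f := phi) (F := proj_labels L); auto. apply proj_labels_ext. apply proj_labels_empty. intros s Hv C. apply sem_proj.
  - destruct (IHphi Hp) as [Mf [Of [If Sf]]]. exists (winA Mf I). split; [apply winA_ok; auto|split; [apply winA_fresh_start; auto|]].
    intros s Hv C. rewrite sem_win, winA_spec, Sf by auto. tauto.
  - destruct Hp as [H1 H2]. apply realizable_seq with (f := phi1) (g := phi2) (adj := false) (I := I); auto. intros s Hv C; apply sem_seqI; auto.
  - destruct Hp as [H1 H2]. apply realizable_seq with (f := phi1) (g := phi2) (adj := true) (I := I); auto. intros s Hv C; apply sem_consI; auto.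
  - apply realizable_iter with (f := phi) (adj := false) (I := I); auto. intros s Hv C; apply sem_plusI; auto.
  - apply realizable_iter with (f := phi) (adj := true) (I := I); auto. intros s Hv C; apply sem_oplusI; auto.
Qed.

End Part15.

Unset Implicit Arguments.
Local Close Scope nat_scope.

Theorem proposition1
  (T A D X : Type)
  (X_fin : exists l : list X, forall x, In x l)
  (inj : T -> X) (inj_inj : forall R1 R2, inj R1 = inj R2 -> R1 = R2)
  (Pset : (Event T A D -> Prop) -> Prop)
  (Pset_E : Pset (fun _ => True))
  (Pset_inter : forall P1 P2, Pset P1 -> Pset P2 -> Pset (fun e => P1 e /\ P2 e))
  (Pset_compl : forall P, Pset P -> Pset (fun e => ~ P e))
  (Pset_type : forall R : T, Pset (fun e => etype e = R))
  (phi : formula T A D X) (Hphi : formula_preds_in Pset phi) :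
  exists M : TCEA T A D X, tcea_ok Pset M /\
    forall s : tstream T A D, valid_stream s ->
      forall C : CE X, sem inj s phi C <-> semT M s C.
Proof.
  destruct (@formula_realizable T A D X inj Pset Pset_E Pset_inter Pset_type phi Hphi) as [M [H1 [_ H3]]].
  exists M. split; auto.
Qed.
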